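(* Assume (A1)–(A4). Let $\mathbf v\in C^1([0,T]\times\overline\Omega)^d$ satisfy $\mathrm{div}_x\mathbf v=0$ in $Q$ and $\mathbf v\cdot\mathbf n=0$ on $(0,T)\times\partial\Omega$. Let $\psi:[0,T]\times\overline\Omega\times[r_0,\infty)\to\mathbb{R}$ and $\phi:[0,T]\times\overline\Omega\to\mathbb{R}$ be regular in the sense below, satisfy the Neumann conditions $\nabla_x\psi\cdot\mathbf n=0$, $\nabla_x\phi\cdot\mathbf n=0$ on $\partial\Omega$, initial conditions $\psi(0)=\psi_0\ge0$, $\phi(0)=\phi_0\ge0$, and (almost everywhere) the modified system $$\partial_t\psi+\mathbf v\cdot\nabla_x\psi-A(r)\Delta_x\psi=-\beta(r,\mathbf v,\mathbf D_x\mathbf v)\psi-\tau(r)\phi\,\partial_r\psi_++2\int_r^\infty\beta(\tilde r,\mathbf v,\mathbf D_x\mathbf v)\kappa(r,\tilde r)\psi_+(t,x,\tilde r)\,d\tilde r,$$ $$\partial_t\phi+\mathbf v\cdot\nabla_x\phi-A_0\Delta_x\phi=-\phi\int_{r_0}^\infty\partial_r(r\tau(r))\psi_+\,dr+2\int_0^{r_0}r\int_{r_0}^\infty\beta(\tilde r,\mathbf v,\mathbf D_x\mathbf v)\kappa(r,\tilde r)\psi_+(t,x,\tilde r)\,d\tilde r\,dr.$$ Then $\psi\ge0$ and $\phi\ge0$ almost everywhere.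
   Context: Fix $d\in\{2,3\}$, $T>0$, a bounded domain $\Omega\subset\mathbb{R}^d$ with $\mathcal C^{1,1}$ boundary and unit outward normal $\mathbf n$, $Q:=(0,T)\times\Omega$, $r_0>0$, constants $K>0$, $A_0>0$. $s_+:=\max(s,0)$. $\mathbf D_x\mathbf v:=\frac12(\nabla_x\mathbf v+(\nabla_x\mathbf v)^T)$ and $\beta(r,\mathbf v,\mathbf D_x\mathbf v)$ means $\beta(r,\mathbf v(t,x),\mathbf D_x\mathbf v(t,x))$. Regularity: $\psi,\partial_t\psi,\partial_r\psi,\nabla_x\psi,\nabla_x^2\psi$ and $\phi,\partial_t\phi,\nabla_x\phi,\nabla_x^2\phi$ are continuous on their closed domains, and for every $m\ge0$ the function $(1+r)^m(|\psi|+|\partial_t\psi|+|\partial_r\psi|+|\nabla_x\psi|+|\nabla_x^2\psi|)$ is bounded on $[0,T]\times\overline\Omega\times[r_0,\infty)$. (A1) $A:(r_0,\infty)\to(0,\infty)$ continuous, nonincreasing, $\lim_{r\to\infty}A(r)=0$. (A2) $\tau:[r_0,\infty)\to[0,\infty)$ nondecreasing, bounded, globally Lipschitz, $\tau(r_0)=0$, $\tau'(r_0)>0$, $K^{-1}r_0\le\tau(r)+r\tau'(r)$ and $\tau(r)+\tau'(r)+r\tau'(r)+\tau(r)/r\le K$. (A3) $\beta:(r_0,\infty)\times\mathbb{R}^d\times\mathbb{R}^{d\times d}\to\mathbb{R}$ smooth, increasing in $r$, $0<\beta\le K$; $\eta(r):=\sup_{\mathbf u,\mathbf D}\partial_r\beta(r,\mathbf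 u,\mathbf D)/\beta(r,\mathbf u,\mathbf D)$ is measurable, nonnegative, $(1+r)\eta(r)\le K$, $\int_{r_0}^\infty\eta\le K$. (A4) $\kappa(r,\tilde r)=1/\tilde r$ if $\tilde r>r_0$ and $0<r<\tilde r$; $\kappa=0$ otherwise. *)

From Stdlib Require Export Reals Lra List.
Export ListNotations.
Open Scope R_scope.

(** * Points of R^d are represented as [nat -> R]; only coordinates i < d matter. *)

Definition sumd (d : nat) (f : nat -> R) : R :=
  fold_right Rplus 0 (map f (seq 0 d)).

Definition prodd (d : nat) (f : nat -> R) : R :=
  fold_right Rmult 1 (map f (seq 0 d)).

Definition normd (d : nat) (x : nat -> R) : R := sqrt (sumd d (fun i => x i * x i)).

Definition vsub (x y : nat -> R) : nat -> R := fun i => x i - y i.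

Definition inRd (d : nat) (x : nat -> R) : Prop := forall i, (d <= i)%nat -> x i = 0.

Definition inRdd (d : nat) (D : nat -> nat -> R) : Prop :=
  forall i j, (d <= i)%nat \/ (d <= j)%nat -> D i j = 0.

Definition upd (x : nat -> R) (i : nat) (s : R) : nat -> R :=
  fun j => if Nat.eqb j i then s else x j.

Definition has_partial (f : (nat -> R) -> R) (i : nat) (x : nat -> R) (l : R) : Prop :=
  derivable_pt_lim (fun s => f (upd x i s)) (x i) l.

Definition closure (d : nat) (Om : (nat -> R) -> Prop) (x : nat -> R) : Prop :=
  inRd d x /\ forall eps, 0 < eps -> exists y, Om y /\ normd d (vsub x y) < eps.

Definition bdry (d : nat) (Om : (nat -> R) -> Prop) (x : nat -> R) : Prop :=
  closure d Om x /\ ~ Om x.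

Definition bounded_domain (d : nat) (Om : (nat -> R) -> Prop) : Prop :=
  (forall x, Om x -> inRd d x) /\
  (exists x, Om x) /\
  (forall x, Om x -> exists eps, 0 < eps /\
       forall y, inRd d y -> normd d (vsub y x) < eps -> Om y) /\
  (forall x y, Om x -> Om y -> exists g : R -> nat -> R,
       g 0 = x /\ g 1 = y /\ (forall s, 0 <= s <= 1 -> Om (g s)) /\
       (forall i s, 0 <= s <= 1 -> forall eps, 0 < eps -> exists del, 0 < del /\
          forall s', 0 <= s' <= 1 -> Rabs (s' - s) < del -> Rabs (g s' i - g s i) < eps)) /\
  (exists M, forall x, Om x -> normd d x <= M).

(** C^{1,1} boundary with unit outward normal [n]: near every boundary point p,
    Om is locally the sublevel set {F < 0} of a function F whose gradient G
    exists, is Lipschitz and nonvanishing; n = G/|G| on the boundary. *)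
Definition C11_boundary_normal (d : nat) (Om : (nat -> R) -> Prop)
    (n : (nat -> R) -> nat -> R) : Prop :=
  forall p, bdry d Om p ->
    exists rho (F : (nat -> R) -> R) (G : nat -> (nat -> R) -> R) L,
      0 < rho /\
      let B := fun y => inRd d y /\ normd d (vsub y p) < rho in
      (forall y i, B y -> (i < d)%nat -> has_partial F i y (G i y)) /\
      (forall y z i, B y -> B z -> (i < d)%nat ->
          Rabs (G i y - G i z) <= L * normd d (vsub y z)) /\
      (forall y, B y -> 0 < normd d (fun i => G i y)) /\
      (forall y, B y -> (Om y <-> F y < 0)) /\
      (forall q, B q -> bdry d Om q -> forall i, (i < d)%nat ->
          n q i = G i q / normd d (fun j => G j q)).

(** * Lebesgue null sets and "almost everywhere" in R^n (via countable box covers) *)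

Definition null (n : nat) (S : (nat -> R) -> Prop) : Prop :=
  forall eps, 0 < eps -> exists lo hi : nat -> nat -> R,
    (forall k i, lo k i <= hi k i) /\
    (forall z, S z -> exists k, forall i, (i < n)%nat -> lo k i <= z i <= hi k i) /\
    (forall N, sum_f_R0 (fun k => prodd n (fun i => hi k i - lo k i)) N <= eps).

Definition ae_on (n : nat) (D P : (nat -> R) -> Prop) : Prop :=
  null n (fun z => D z /\ ~ P z).

(** coordinates: z = (t, x_0..x_{d-1}, r) *)
Definition zx (d : nat) (z : nat -> R) : nat -> R :=
  fun i => if Nat.ltb i d then z (S i) else 0.

Definition ae_txr (d : nat) (D P : R -> (nat -> R) -> R -> Prop) : Prop :=
  ae_on (S (S d)) (fun z => D (z O) (zx d z) (z (S d)))
                  (fun z => P (z O) (zx d z) (z (S d))).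

Definition ae_tx (d : nat) (D P : R -> (nat -> R) -> Prop) : Prop :=
  ae_on (S d) (fun z => D (z O) (zx d z)) (fun z => P (z O) (zx d z)).

Definition ae_r (D P : R -> Prop) : Prop :=
  ae_on 1 (fun z => D (z O)) (fun z => P (z O)).

(** * Henstock-Kurzweil (gauge) integral *)

(** list of (left end, tag, right end) forming a del-fine tagged partition of [a,b] *)
Fixpoint fine (del : R -> R) (a b : R) (P : list (R * R * R)) : Prop :=
  match P with
  | nil => a = b
  | (u, t, w) :: P' =>
      u = a /\ u <= t <= w /\ t - del t < u /\ w < t + del t /\ fine del w b P'
  end.

Fixpoint rsum (f : R -> R) (P : list (R * R * R)) : R :=
  match P with
  | nil => 0
  | (u, t, w) :: P' => f t * (w - u) + rsum f P'
  end.

Definition HKint (f : R -> R) (a b I : R) : Prop :=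
  a <= b /\ forall eps, 0 < eps -> exists del : R -> R,
    (forall t, a <= t <= b -> 0 < del t) /\
    forall P, fine del a b P -> Rabs (rsum f P - I) < eps.

Definition HKint_inf (f : R -> R) (a I : R) : Prop :=
  (forall b, a <= b -> exists J, HKint f a b J) /\
  (forall eps, 0 < eps -> exists B, forall b J, B <= b -> a <= b -> HKint f a b J ->
       Rabs (J - I) < eps).

Definition cont3_on (d : nat) (S : R -> (nat -> R) -> R -> Prop)
    (f : R -> (nat -> R) -> R -> R) : Prop :=
  forall t x r, S t x r -> forall eps, 0 < eps -> exists del, 0 < del /\
    forall t' x' r', S t' x' r' ->
      Rabs (t' - t) + normd d (vsub x' x) + Rabs (r' - r) < del ->
      Rabs (f t' x' r' - f t x r) < eps.

Definition cont2_on (d : nat) (S : R -> (nat -> R) -> Prop)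
    (f : R -> (nat -> R) -> R) : Prop :=
  forall t x, S t x -> forall eps, 0 < eps -> exists del, 0 < del /\
    forall t' x', S t' x' ->
      Rabs (t' - t) + normd d (vsub x' x) < del ->
      Rabs (f t' x' - f t x) < eps.

Definition cont_on_n (n : nat) (U : (nat -> R) -> Prop) (g : (nat -> R) -> R) : Prop :=
  forall z, U z -> forall eps, 0 < eps -> exists del, 0 < del /\
    forall y, U y -> normd n (vsub y z) < del -> Rabs (g y - g z) < eps.

Definition smooth_on (n : nat) (U : (nat -> R) -> Prop) (f : (nat -> R) -> R) : Prop :=
  exists F : list nat -> (nat -> R) -> R,
    (forall z, U z -> F nil z = f z) /\
    (forall l i z, (i < n)%nat -> U z -> has_partial (F l) i z (F (i :: l) z)) /\
    (forall l, cont_on_n n U (F l)).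

Definition cQ d T Om (t : R) (x : nat -> R) : Prop := 0 <= t <= T /\ closure d Om x.
Definition oQ T (Om : (nat -> R) -> Prop) (t : R) (x : nat -> R) : Prop := 0 < t < T /\ Om x.
Definition cQR d T Om r0 t x (r : R) : Prop := cQ d T Om t x /\ r0 <= r.
Definition oQR T Om r0 t x (r : R) : Prop := oQ T Om t x /\ r0 < r.

(** * Regularity of the unknowns; derivatives are given as continuous extensions *)

(** v in C^1([0,T] x closure Om)^d ; vt i = d_t v_i, vx i j = d_{x_j} v_i *)
Definition reg_v d T Om (v : nat -> R -> (nat -> R) -> R)
    (vt : nat -> R -> (nat -> R) -> R) (vx : nat -> nat -> R -> (nat -> R) -> R) : Prop :=
  (forall i, (i < d)%nat ->
     cont2_on d (cQ d T Om) (v i) /\ cont2_on d (cQ d T Om) (vt i) /\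
     (forall j, (j < d)%nat -> cont2_on d (cQ d T Om) (vx i j))) /\
  (forall i t x, (i < d)%nat -> oQ T Om t x ->
     derivable_pt_lim (fun s => v i s x) t (vt i t x) /\
     forall j, (j < d)%nat -> has_partial (v i t) j x (vx i j t x)).

Definition reg_psi d T Om r0 (psi : R -> (nat -> R) -> R -> R)
    (psit psir : R -> (nat -> R) -> R -> R)
    (psix : nat -> R -> (nat -> R) -> R -> R)
    (psixx : nat -> nat -> R -> (nat -> R) -> R -> R) : Prop :=
  let S := cQR d T Om r0 in
  (cont3_on d S psi /\ cont3_on d S psit /\ cont3_on d S psir /\
   (forall i, (i < d)%nat -> cont3_on d S (psix i)) /\
   (forall i j, (i < d)%nat -> (j < d)%nat -> cont3_on d S (psixx i j))) /\
  (forall t x r, oQR T Om r0 t x r ->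
     derivable_pt_lim (fun s => psi s x r) t (psit t x r) /\
     derivable_pt_lim (fun s => psi t x s) r (psir t x r) /\
     (forall i, (i < d)%nat -> has_partial (fun y => psi t y r) i x (psix i t x r)) /\
     (forall i j, (i < d)%nat -> (j < d)%nat ->
        has_partial (fun y => psix i t y r) j x (psixx i j t x r))) /\
  (forall m, 0 <= m -> exists M, forall t x r, S t x r ->
     Rpower (1 + r) m *
       (Rabs (psi t x r) + Rabs (psit t x r) + Rabs (psir t x r) +
        sumd d (fun i => Rabs (psix i t x r)) +
        sumd d (fun i => sumd d (fun j => Rabs (psixx i j t x r)))) <= M).

Definition reg_phi d T Om (phi phit : R -> (nat -> R) -> R)
    (phix : nat -> R -> (nat -> R) -> R)
    (phixx : nat -> nat -> R -> (nat -> R) -> R) : Prop :=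
  let S := cQ d T Om in
  (cont2_on d S phi /\ cont2_on d S phit /\
   (forall i, (i < d)%nat -> cont2_on d S (phix i)) /\
   (forall i j, (i < d)%nat -> (j < d)%nat -> cont2_on d S (phixx i j))) /\
  (forall t x, oQ T Om t x ->
     derivable_pt_lim (fun s => phi s x) t (phit t x) /\
     (forall i, (i < d)%nat -> has_partial (fun y => phi t y) i x (phix i t x)) /\
     (forall i j, (i < d)%nat -> (j < d)%nat ->
        has_partial (fun y => phix i t y) j x (phixx i j t x))).

Definition pos (s : R) : R := Rmax s 0.

Definition kappa (r0 r rt : R) : R :=
  if Rlt_dec r0 rt then
    (if Rlt_dec 0 r then (if Rlt_dec r rt then / rt else 0) else 0)
  else 0.

Definition vecv d (v : nat -> R -> (nat -> R) -> R) t x : nat -> R :=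
  fun i => if Nat.ltb i d then v i t x else 0.

Definition symgrad d (vx : nat -> nat -> R -> (nat -> R) -> R) t x : nat -> nat -> R :=
  fun i j => if andb (Nat.ltb i d) (Nat.ltb j d)
             then (vx i j t x + vx j i t x) / 2 else 0.

(** beta as a function of z = (r, u, D) in R^{1 + d + d*d} *)
Definition beta_z d (beta : R -> (nat -> R) -> (nat -> nat -> R) -> R) (z : nat -> R) : R :=
  beta (z O) (fun i => if Nat.ltb i d then z (S i) else 0)
       (fun i j => if andb (Nat.ltb i d) (Nat.ltb j d) then z (S d + i * d + j)%nat else 0).

Definition hypA1 (r0 : R) (A : R -> R) : Prop :=
  (forall r, r0 < r -> 0 < A r) /\
  (forall r, r0 < r -> continuity_pt A r) /\
  (forall r s, r0 < r -> r <= s -> A s <= A r) /\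
  (forall eps, 0 < eps -> exists M, forall r, M <= r -> r0 < r -> Rabs (A r) < eps).

(** (A2); [taud] is an a.e. derivative of [tau] *)
Definition hypA2 (r0 K : R) (tau taud : R -> R) : Prop :=
  (forall r, r0 <= r -> 0 <= tau r) /\
  (forall r s, r0 <= r -> r <= s -> tau r <= tau s) /\
  (exists M, forall r, r0 <= r -> Rabs (tau r) <= M) /\
  (exists L, forall r s, r0 <= r -> r0 <= s -> Rabs (tau r - tau s) <= L * Rabs (r - s)) /\
  tau r0 = 0 /\
  (exists l, 0 < l /\ forall eps, 0 < eps -> exists del, 0 < del /\
      forall h, 0 < h < del -> Rabs ((tau (r0 + h) - tau r0) / h - l) < eps) /\
  ae_r (fun r => r0 < r)
    (fun r => derivable_pt_lim tau r (taud r) /\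
              / K * r0 <= tau r + r * taud r /\
              tau r + taud r + r * taud r + tau r / r <= K).

Definition hypA3 (d : nat) (r0 K : R) (beta : R -> (nat -> R) -> (nat -> nat -> R) -> R)
    (eta : R -> R) : Prop :=
  smooth_on (S d + d * d) (fun z => inRd (S d + d * d) z /\ r0 < z O) (beta_z d beta) /\
  (forall r s u D, inRd d u -> inRdd d D -> r0 < r -> r < s -> beta r u D < beta s u D) /\
  (forall r u D, inRd d u -> inRdd d D -> r0 < r -> 0 < beta r u D <= K) /\
  (forall r, r0 < r ->
     is_lub (fun q => exists u D l, inRd d u /\ inRdd d D /\
                derivable_pt_lim (fun s => beta s u D) r l /\ q = l / beta r u D)
            (eta r)) /\
  (forall r, r0 < r -> 0 <= eta r /\ (1 + r) * eta r <= K) /\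
  (forall b, r0 <= b -> exists I, HKint eta r0 b I /\ I <= K).

(** For a fixed size [r], the equation for [psi] reads [L psi = - beta psi - tau phi d_r psi_+ + 2 I]
    with [L] the transport-diffusion operator and [I >= 0].  Where [psi < 0], [psi_+] vanishes nearby,
    so [d_r psi_+ = 0] and the right-hand side is positive; where [phi < 0], the right-hand side of
    the equation for [phi] is nonnegative because [tau + r tau' > 0] by (A2).  Hence each unknown [w]
    satisfies [L w >= 0] wherever [w < 0]: first at the points where the equation holds, which are
    dense since a box of positive volume is not null, then everywhere by continuity.  A parabolic
    minimum principle with Neumann boundary conditions, whose boundary case uses the [C^{1,1}] chart
    to produce inward directions, then gives [w >= 0] everywhere, in particular almost everywhere. *)

From Stdlib Require Import Lia ZArith FunctionalExtensionality Classical ClassicalEpsilon.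

Lemma sumd_S : forall d f, sumd (S d) f = sumd d f + f d.
Proof.
  intros d f. unfold sumd. rewrite seq_S, map_app, fold_right_app. simpl.
  induction (map f (seq 0 d)); simpl; lra.
Qed.

Lemma prodd_S : forall d f, prodd (S d) f = prodd d f * f d.
Proof.
  intros d f. unfold prodd. rewrite seq_S, map_app, fold_right_app. simpl.
  induction (map f (seq 0 d)) as [|a l IH]; simpl; [ring|]. rewrite IH. ring.
Qed.

Lemma sumd_ext : forall d f g, (forall i, (i < d)%nat -> f i = g i) -> sumd d f = sumd d g.
Proof.
  induction d; intros f g H; [reflexivity|]. rewrite !sumd_S, (IHd f g), (H d); auto; lia.
Qed.

Lemma prodd_ext : forall d f g, (forall i, (i < d)%nat -> f i = g i) -> prodd d f = prodd d g.
Proof.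
  induction d; intros f g H; [reflexivity|]. rewrite !prodd_S, (IHd f g), (H d); auto; lia.
Qed.

Lemma sumd_plus : forall d f g, sumd d (fun i => f i + g i) = sumd d f + sumd d g.
Proof. induction d; intros; [unfold sumd; simpl; ring|]. rewrite !sumd_S, IHd. ring. Qed.

Lemma sumd_scal : forall d c f, sumd d (fun i => c * f i) = c * sumd d f.
Proof. induction d; intros; [unfold sumd; simpl; ring|]. rewrite !sumd_S, IHd. ring. Qed.

Lemma sumd_minus : forall d f g, sumd d (fun i => f i - g i) = sumd d f - sumd d g.
Proof. induction d; intros; [unfold sumd; simpl; ring|]. rewrite !sumd_S, IHd. ring. Qed.

Lemma sumd_const : forall d c, sumd d (fun _ => c) = INR d * c.
Proof. induction d; intros; [unfold sumd; simpl; ring|]. rewrite sumd_S, IHd, S_INR. ring. Qed.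

Lemma sumd_zero : forall d f, (forall i, (i < d)%nat -> f i = 0) -> sumd d f = 0.
Proof.
  intros d f H. rewrite (sumd_ext d f (fun _ => 0)) by auto. rewrite sumd_const. ring.
Qed.

Lemma sumd_le : forall d f g, (forall i, (i < d)%nat -> f i <= g i) -> sumd d f <= sumd d g.
Proof.
  induction d; intros f g H; [unfold sumd; simpl; lra|]. rewrite !sumd_S.
  assert (f d <= g d) by (apply H; lia).
  assert (sumd d f <= sumd d g) by (apply IHd; intros; apply H; lia). lra.
Qed.

Lemma sumd_nonneg : forall d f, (forall i, (i < d)%nat -> 0 <= f i) -> 0 <= sumd d f.
Proof.
  intros d f H. rewrite <- (sumd_zero d (fun _ => 0)) by auto. apply sumd_le; auto.
Qed.

Lemma sumd_abs : forall d f, Rabs (sumd d f) <= sumd d (fun i => Rabs (f i)).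
Proof.
  induction d; intros; [unfold sumd; simpl; rewrite Rabs_R0; lra|]. rewrite !sumd_S.
  eapply Rle_trans; [apply Rabs_triang|]. specialize (IHd f). lra.
Qed.

Lemma sumd_term_le : forall d f k, (forall i, (i < d)%nat -> 0 <= f i) -> (k < d)%nat -> f k <= sumd d f.
Proof.
  induction d; intros f k H Hk; [lia|]. rewrite sumd_S.
  destruct (Nat.eq_dec k d) as [->|Hne].
  - assert (0 <= sumd d f) by (apply sumd_nonneg; intros; apply H; lia). lra.
  - assert (f k <= sumd d f) by (apply IHd; [intros; apply H; lia| lia]).
    assert (0 <= f d) by (apply H; lia). lra.
Qed.

Lemma prodd_nonneg : forall d f, (forall i, (i < d)%nat -> 0 <= f i) -> 0 <= prodd d f.
Proof.
  induction d; intros f H; [unfold prodd; simpl; lra|]. rewrite prodd_S.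
  apply Rmult_le_pos; [apply IHd; intros; apply H; lia| apply H; lia].
Qed.

Lemma prodd_pos : forall d f, (forall i, (i < d)%nat -> 0 < f i) -> 0 < prodd d f.
Proof.
  induction d; intros f H; [unfold prodd; simpl; lra|]. rewrite prodd_S.
  apply Rmult_lt_0_compat; [apply IHd; intros; apply H; lia| apply H; lia].
Qed.

Lemma prodd_1 : forall f, prodd 1 f = f O.
Proof. intros. unfold prodd. simpl. ring. Qed.

Definition unit_vec (k : nat) : nat -> R := fun i => if Nat.eqb i k then 1 else 0.

Lemma unit_vec_inRd : forall d k, (k < d)%nat -> inRd d (unit_vec k).
Proof. intros d k Hk j Hj. unfold unit_vec. destruct (Nat.eqb_spec j k); [lia|auto]. Qed.

Lemma sumd_unit_vec : forall d k s f, (k < d)%nat -> sumd d (fun j => (s * unit_vec k j) * f j) = s * f k.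
Proof.
  induction d; intros k s f Hk; [lia|]. rewrite sumd_S. unfold unit_vec at 2.
  destruct (Nat.eqb_spec d k) as [->|Hne].
  - rewrite sumd_zero; [ring|]. intros i Hi. unfold unit_vec. destruct (Nat.eqb_spec i k); [lia|ring].
  - rewrite IHd; [ring|lia].
Qed.

Definition l1d (d : nat) (x : nat -> R) : R := sumd d (fun j => Rabs (x j)).

Lemma l1d_nonneg : forall d x, 0 <= l1d d x.
Proof. intros; apply sumd_nonneg; intros; apply Rabs_pos. Qed.

Lemma l1d_triang : forall d x y z, l1d d (vsub x z) <= l1d d (vsub x y) + l1d d (vsub y z).
Proof.
  intros. unfold l1d. rewrite <- sumd_plus. apply sumd_le. intros; unfold vsub.
  replace (x i - z i) with ((x i - y i) + (y i - z i)) by ring. apply Rabs_triang.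
Qed.

Lemma normd_nonneg : forall d x, 0 <= normd d x.
Proof. intros; apply sqrt_pos. Qed.

Lemma normd_sym : forall d x y, normd d (vsub x y) = normd d (vsub y x).
Proof. intros. unfold normd. f_equal. apply sumd_ext. intros; unfold vsub; ring. Qed.

Lemma normd_vsub_self : forall d x, normd d (vsub x x) = 0.
Proof. intros. unfold normd. rewrite sumd_zero; [apply sqrt_0|]. intros; unfold vsub; ring. Qed.

Lemma coord_le_normd : forall d x i, (i < d)%nat -> Rabs (x i) <= normd d x.
Proof.
  intros d x i Hi. unfold normd. rewrite <- sqrt_Rsqr_abs. apply sqrt_le_1_alt.
  unfold Rsqr. apply (sumd_term_le d (fun i => x i * x i)); auto. intros; nra.
Qed.

Lemma normd_le_l1d : forall d x, normd d x <= l1d d x.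
Proof.
  intros d x. unfold normd. rewrite <- (sqrt_Rsqr _ (l1d_nonneg d x)). apply sqrt_le_1_alt.
  unfold Rsqr, l1d. induction d; [unfold sumd; simpl; lra|]. rewrite !sumd_S.
  assert (0 <= sumd d (fun i => Rabs (x i))) by (apply sumd_nonneg; intros; apply Rabs_pos).
  assert (x d * x d = Rabs (x d) * Rabs (x d)) by (rewrite <- Rabs_mult, Rabs_pos_eq; nra).
  pose proof (Rabs_pos (x d)). nra.
Qed.

Lemma l1d_le_normd : forall d x, l1d d x <= INR d * normd d x.
Proof. intros. unfold l1d. rewrite <- sumd_const. apply sumd_le. intros; apply coord_le_normd; auto. Qed.

Lemma normd_small : forall d x eps, 0 < eps -> (forall i, (i < d)%nat -> Rabs (x i) < eps / INR (S d)) ->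
  normd d x < eps.
Proof.
  intros d x eps He H. eapply Rle_lt_trans; [apply normd_le_l1d|].
  apply Rle_lt_trans with (sumd d (fun _ => eps / INR (S d))).
  - apply sumd_le; intros; apply Rlt_le; auto.
  - rewrite sumd_const, S_INR. pose proof (pos_INR d).
    apply Rmult_lt_reg_r with (INR d + 1); [lra|]. field_simplify; [nra|lra].
Qed.

Lemma Rabs_le_bounds : forall x a, Rabs x <= a -> - a <= x <= a.
Proof. intros x a H. pose proof (Rle_abs x). pose proof (Rle_abs (- x)). rewrite Rabs_Ropp in *. lra. Qed.

Definition lim_near {X : Type} (near : R -> X -> Prop) (f : X -> R) (l : R) : Prop :=
  forall eps, 0 < eps -> exists del, 0 < del /\ forall x, near del x -> Rabs (f x - l) < eps.

Definition near_mono {X : Type} (near : R -> X -> Prop) : Prop :=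
  forall a b x, 0 < a -> a <= b -> near a x -> near b x.

Definition near_0_right : R -> R -> Prop := fun del s => 0 < s < del.

Lemma near_0_right_mono : near_mono near_0_right.
Proof. intros a b x Ha Hab Hx. unfold near_0_right in *. lra. Qed.

Lemma lim_near_const : forall X (near : R -> X -> Prop) c, lim_near near (fun _ => c) c.
Proof. intros X near c eps He. exists 1. split; [lra|]. intros. rewrite Rminus_diag, Rabs_R0; auto. Qed.

Lemma lim_near_id : lim_near near_0_right (fun s => s) 0.
Proof.
  intros eps He. exists eps. split; auto. intros x Hx. unfold near_0_right in Hx.
  rewrite Rminus_0_r, Rabs_pos_eq; lra.
Qed.

Lemma lim_near_plus : forall X (near : R -> X -> Prop) f g a b, near_mono near ->
  lim_near near f a -> lim_near near g b -> lim_near near (fun x => f x + g x) (a + b).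
Proof.
  intros X near f g a b Hm Hf Hg eps He.
  destruct (Hf (eps/2)) as [d1 [Hd1 H1]]; [lra|]. destruct (Hg (eps/2)) as [d2 [Hd2 H2]]; [lra|].
  exists (Rmin d1 d2). split; [apply Rmin_pos; auto|]. intros x Hx.
  assert (near d1 x) by (apply Hm with (Rmin d1 d2); auto; [apply Rmin_pos; auto| apply Rmin_l]).
  assert (near d2 x) by (apply Hm with (Rmin d1 d2); auto; [apply Rmin_pos; auto| apply Rmin_r]).
  specialize (H1 x H). specialize (H2 x H0).
  replace (f x + g x - (a + b)) with ((f x - a) + (g x - b)) by ring.
  eapply Rle_lt_trans; [apply Rabs_triang|]. lra.
Qed.

Lemma lim_near_opp : forall X (near : R -> X -> Prop) f a,
  lim_near near f a -> lim_near near (fun x => - f x) (- a).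
Proof.
  intros X near f a Hf eps He. destruct (Hf eps He) as [d [Hd H]]. exists d; split; auto.
  intros x Hx. replace (- f x - - a) with (- (f x - a)) by ring. rewrite Rabs_Ropp; auto.
Qed.

Lemma lim_near_minus : forall X (near : R -> X -> Prop) f g a b, near_mono near ->
  lim_near near f a -> lim_near near g b -> lim_near near (fun x => f x - g x) (a - b).
Proof. intros. apply (lim_near_plus X near f (fun x => - g x) a (- b)); auto. apply lim_near_opp; auto. Qed.

Lemma lim_near_mult : forall X (near : R -> X -> Prop) f g a b, near_mono near ->
  lim_near near f a -> lim_near near g b -> lim_near near (fun x => f x * g x) (a * b).
Proof.
  intros X near f g a b Hm Hf Hg eps He.
  set (e1 := Rmin 1 (eps / (2 * (Rabs b + 1)))).
  set (e2 := eps / (2 * (Rabs a + 2))).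
  pose proof (Rabs_pos a). pose proof (Rabs_pos b).
  assert (He1 : 0 < e1) by (unfold e1; apply Rmin_pos; [lra|]; apply Rdiv_lt_0_compat; lra).
  assert (He2 : 0 < e2) by (unfold e2; apply Rdiv_lt_0_compat; lra).
  destruct (Hf e1 He1) as [d1 [Hd1 H1]]. destruct (Hg e2 He2) as [d2 [Hd2 H2]].
  exists (Rmin d1 d2). split; [apply Rmin_pos; auto|]. intros x Hx.
  assert (Hn1 : near d1 x) by (apply Hm with (Rmin d1 d2); auto; [apply Rmin_pos; auto| apply Rmin_l]).
  assert (Hn2 : near d2 x) by (apply Hm with (Rmin d1 d2); auto; [apply Rmin_pos; auto| apply Rmin_r]).
  specialize (H1 x Hn1). specialize (H2 x Hn2).
  replace (f x * g x - a * b) with ((f x - a) * b + f x * (g x - b)) by ring.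
  eapply Rle_lt_trans; [apply Rabs_triang|]. rewrite !Rabs_mult.
  assert (Hfx : Rabs (f x) <= Rabs a + 1).
  { replace (f x) with (a + (f x - a)) by ring. eapply Rle_trans; [apply Rabs_triang|].
    assert (e1 <= 1) by apply Rmin_l. lra. }
  assert (Rabs (f x - a) * Rabs b <= eps / 2).
  { assert (e1 <= eps / (2 * (Rabs b + 1))) by apply Rmin_r.
    apply Rle_trans with (eps / (2 * (Rabs b + 1)) * (Rabs b + 1)).
    - apply Rmult_le_compat; try apply Rabs_pos; lra.
    - right; field; lra. }
  assert (Rabs (f x) * Rabs (g x - b) < eps / 2).
  { pose proof (Rabs_pos (f x)). pose proof (Rabs_pos (g x - b)).
    apply Rle_lt_trans with ((Rabs a + 1) * Rabs (g x - b)); [apply Rmult_le_compat_r; auto|].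
    apply Rlt_le_trans with ((Rabs a + 2) * e2); [nra|]. unfold e2. right. field. lra. }
  lra.
Qed.

Lemma lim_near_sumd : forall X (near : R -> X -> Prop) d (F : nat -> X -> R) (L : nat -> R), near_mono near ->
  (forall i, (i < d)%nat -> lim_near near (F i) (L i)) ->
  lim_near near (fun x => sumd d (fun i => F i x)) (sumd d L).
Proof.
  intros X near d F L Hm. induction d; intros H.
  - unfold sumd; simpl. apply lim_near_const.
  - replace (fun x => sumd (S d) (fun i => F i x)) with (fun x => sumd d (fun i => F i x) + F d x)
      by (apply functional_extensionality; intro; rewrite sumd_S; reflexivity).
    rewrite sumd_S. apply lim_near_plus; [auto| apply IHd; intros; apply H; lia | apply H; lia].
Qed.

Lemma min_pos_family : forall (d : nat) (P : nat -> R -> Prop),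
  (forall i a b, 0 < a -> a <= b -> P i b -> P i a) ->
  (forall i, (i < d)%nat -> exists del, 0 < del /\ P i del) ->
  exists del, 0 < del /\ forall i, (i < d)%nat -> P i del.
Proof.
  induction d; intros P Hmono H.
  - exists 1; split; [lra|]. intros; lia.
  - destruct (IHd P Hmono) as [d1 [Hd1 H1]]; [intros; apply H; lia|].
    destruct (H d) as [d2 [Hd2 H2]]; [lia|].
    exists (Rmin d1 d2); split; [apply Rmin_pos; auto|].
    intros i Hi. destruct (Nat.eq_dec i d) as [->|Hne].
    + apply Hmono with d2; auto; [apply Rmin_pos; auto| apply Rmin_r].
    + apply Hmono with d1; [apply Rmin_pos; auto| apply Rmin_l| apply H1; lia].
Qed.

Lemma max_index_family : forall d (P : nat -> nat -> Prop),
  (forall i, (i < d)%nat -> exists N, forall n, (N <= n)%nat -> P i n) ->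
  exists N, forall i, (i < d)%nat -> forall n, (N <= n)%nat -> P i n.
Proof.
  induction d; intros P H; [exists O; intros; lia|].
  destruct (IHd P) as [N1 H1]; [intros; apply H; lia|]. destruct (H d) as [N2 H2]; [lia|].
  exists (max N1 N2). intros i Hi n Hn. destruct (Nat.eq_dec i d) as [->|].
  - apply H2; lia.
  - apply H1; lia.
Qed.

Lemma continuity_pt_eps : forall f x, continuity_pt f x -> forall eps, 0 < eps -> exists del, 0 < del /\
  forall y, Rabs (y - x) < del -> Rabs (f y - f x) < eps.
Proof.
  intros f x H eps He. destruct (H eps He) as [del [Hdel Hd]]. exists del. split; auto. intros y Hy.
  destruct (Req_dec y x) as [->|Hne]; [rewrite Rminus_diag, Rabs_R0; auto|].
  apply (Hd y). split; [split; [exact I| auto]| exact Hy].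
Qed.

Lemma derivable_sumd : forall d (F : nat -> R -> R) (D : nat -> R) x,
  (forall i, (i < d)%nat -> derivable_pt_lim (F i) x (D i)) ->
  derivable_pt_lim (fun s => sumd d (fun i => F i s)) x (sumd d D).
Proof.
  induction d; intros F D x H; [apply derivable_pt_lim_const|].
  rewrite sumd_S. apply derivable_pt_lim_ext with (fun s => sumd d (fun i => F i s) + F d s).
  - intro; rewrite sumd_S; auto.
  - apply (derivable_pt_lim_plus (fun s => sumd d (fun i => F i s)) (F d)).
    + apply IHd; intros; apply H; lia.
    + apply H; lia.
Qed.

Lemma derivable_shift : forall f x l, derivable_pt_lim (fun s => f (x + s)) 0 l -> derivable_pt_lim f x l.
Proof.
  intros f x l H eps He. destruct (H eps He) as [del Hd]. exists del. intros h Hh Hhd.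
  specialize (Hd h Hh Hhd). rewrite Rplus_0_l, Rplus_0_r in Hd. auto.
Qed.

Lemma derivable_locally_zero : forall f x l, derivable_pt_lim f x l ->
  (exists eta, 0 < eta /\ forall s, Rabs (s - x) < eta -> f s = 0) -> l = 0.
Proof.
  intros f x l Hd [eta [Heta Hz]]. apply NNPP; intro Hl.
  destruct (Hd (Rabs l) (Rabs_pos_lt l Hl)) as [del Hdel].
  pose proof (cond_pos del).
  set (h := Rmin (del / 2) (eta / 2)).
  assert (Hh : 0 < h) by (unfold h; apply Rmin_pos; lra).
  assert (h <= del / 2) by apply Rmin_l. assert (h <= eta / 2) by apply Rmin_r.
  specialize (Hdel h ltac:(lra) ltac:(rewrite Rabs_pos_eq; lra)).
  rewrite (Hz (x + h)), (Hz x) in Hdel.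
  - replace ((0 - 0) / h - l) with (- l) in Hdel by (field; lra). rewrite Rabs_Ropp in Hdel. lra.
  - rewrite Rminus_diag, Rabs_R0; lra.
  - replace (x + h - x) with h by ring. rewrite Rabs_pos_eq; lra.
Qed.

Lemma MVT_between : forall f f' a b,
  (forall c, Rmin a b <= c <= Rmax a b -> derivable_pt_lim f c (f' c)) ->
  exists c, Rmin a b <= c <= Rmax a b /\ f b - f a = f' c * (b - a).
Proof.
  intros f f' a b H. destruct (Rtotal_order a b) as [Hab|[Hab|Hab]].
  - destruct (MVT_cor2 f f' a b Hab) as [c [Hc1 Hc2]].
    + intros c Hc; apply H; rewrite Rmin_left, Rmax_right by lra; lra.
    + exists c; rewrite Rmin_left, Rmax_right by lra; split; [lra|auto].
  - subst. exists b. rewrite Rmin_left, Rmax_left by lra. split; [lra|ring].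
  - destruct (MVT_cor2 f f' b a Hab) as [c [Hc1 Hc2]].
    + intros c Hc; apply H; rewrite Rmin_right, Rmax_left by lra; lra.
    + exists c; rewrite Rmin_right, Rmax_left by lra. split; [lra|]. lra.
Qed.

Lemma MVT_upper_bound : forall f df a b M, a < b ->
  (forall eps, 0 < eps -> exists del, 0 < del /\ forall x, a < x < a + del -> Rabs (f x - f a) < eps) ->
  (forall x, a < x <= b -> derivable_pt_lim f x (df x)) ->
  (forall x, a < x <= b -> df x <= M) ->
  f b - f a <= M * (b - a).
Proof.
  intros f df a b M Hab Hc Hd HM. apply Rnot_lt_le; intro Hlt.
  set (e := (f b - f a - M * (b - a)) / 4).
  assert (He : 0 < e) by (unfold e; lra).
  destruct (Hc e He) as [del [Hdel Hx]].
  pose proof (Rabs_pos M).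
  set (eta := Rmin (Rmin (del/2) ((b - a)/2)) (e / (1 + Rabs M))).
  assert (Heta : 0 < eta) by (unfold eta; repeat apply Rmin_pos; try lra; apply Rdiv_lt_0_compat; lra).
  assert (Heta1 : eta <= del / 2) by (unfold eta; eapply Rle_trans; [apply Rmin_l|apply Rmin_l]).
  assert (Heta2 : eta <= (b - a) / 2) by (unfold eta; eapply Rle_trans; [apply Rmin_l|apply Rmin_r]).
  assert (Heta3 : eta <= e / (1 + Rabs M)) by (unfold eta; apply Rmin_r).
  destruct (MVT_cor2 f df (a + eta) b) as [c [Hc1 Hc2]]; [lra| intros c Hcc; apply Hd; lra|].
  assert (Hfc : df c <= M) by (apply HM; lra).
  assert (Habs : Rabs (f (a + eta) - f a) < e) by (apply Hx; lra).
  assert (HMeta : Rabs M * eta <= e).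
  { apply Rmult_le_compat_l with (r := 1 + Rabs M) in Heta3; [|lra].
    field_simplify in Heta3; [|lra]. nra. }
  apply Rabs_def2 in Habs.
  assert (df c * (b - (a + eta)) <= M * (b - (a + eta))) by (apply Rmult_le_compat_r; lra).
  assert (- (M * eta) <= Rabs M * eta) by (pose proof (Rle_abs (- M)); rewrite Rabs_Ropp in *; nra).
  unfold e in *. lra.
Qed.

Definition right_cont0 (f : R -> R) : Prop := lim_near near_0_right f (f 0).

Lemma min_first_order : forall g G1 s0, 0 < s0 ->
  (forall s, 0 < s < s0 -> g 0 <= g s) -> right_cont0 g ->
  (forall s, 0 < s < s0 -> derivable_pt_lim g s (G1 s)) -> right_cont0 G1 -> 0 <= G1 0.
Proof.
  intros g G1 s0 Hs0 Hmin Hg Hd HG. apply Rnot_lt_le; intro Hlt.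
  destruct (HG (- G1 0 / 2)) as [del [Hdel H]]; [lra|].
  set (b := Rmin del s0 / 2).
  assert (Hb : 0 < b) by (unfold b; apply Rdiv_lt_0_compat; [apply Rmin_pos|]; lra).
  assert (Hb1 : b < del) by (unfold b; pose proof (Rmin_l del s0); lra).
  assert (Hb2 : b < s0) by (unfold b; pose proof (Rmin_r del s0); lra).
  assert (g b - g 0 <= (G1 0 / 2) * (b - 0)).
  { apply MVT_upper_bound with G1; [lra| |intros; apply Hd; lra|].
    - intros eps He. destruct (Hg eps He) as [e [He' Hg']]. exists e. split; auto.
      intros x Hx. apply Hg'. red. lra.
    - intros x Hx. specialize (H x ltac:(red; lra)). apply Rabs_def2 in H. lra. }
  specialize (Hmin b ltac:(lra)). nra.
Qed.

(** If [G2 0 < 0], then [G1 < 0] just right of [0] and [g] decreases there. *)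
Lemma min_second_order : forall g G1 G2 s0, 0 < s0 ->
  (forall s, 0 < s < s0 -> g 0 <= g s) -> right_cont0 g ->
  (forall s, 0 < s < s0 -> derivable_pt_lim g s (G1 s)) -> right_cont0 G1 -> G1 0 = 0 ->
  (forall s, 0 < s < s0 -> derivable_pt_lim G1 s (G2 s)) -> right_cont0 G2 -> 0 <= G2 0.
Proof.
  intros g G1 G2 s0 Hs0 Hmin Hg Hd HG1 H10 Hd2 HG2. apply Rnot_lt_le; intro Hlt.
  assert (Hrc : forall f, right_cont0 f -> forall eps, 0 < eps ->
             exists del, 0 < del /\ forall x, 0 < x < 0 + del -> Rabs (f x - f 0) < eps).
  { intros f Hf eps He. destruct (Hf eps He) as [e [He' Hf']]. exists e. split; auto.
    intros x Hx. apply Hf'. red. lra. }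
  destruct (HG2 (- G2 0 / 2)) as [del [Hdel H]]; [lra|].
  set (b := Rmin del s0 / 2).
  assert (Hb : 0 < b) by (unfold b; apply Rdiv_lt_0_compat; [apply Rmin_pos|]; lra).
  assert (Hb1 : b < del) by (unfold b; pose proof (Rmin_l del s0); lra).
  assert (Hb2 : b < s0) by (unfold b; pose proof (Rmin_r del s0); lra).
  assert (HG1neg : forall sg, 0 < sg <= b -> G1 sg <= (G2 0 / 2) * sg).
  { intros sg Hsg. assert (G1 sg - G1 0 <= (G2 0 / 2) * (sg - 0)); [|lra].
    apply MVT_upper_bound with G2; [lra| apply Hrc; auto| intros; apply Hd2; lra|].
    intros x Hx. specialize (H x ltac:(red; lra)). apply Rabs_def2 in H. lra. }
  assert (g (b/2) - g 0 <= 0 * (b/2 - 0)).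
  { apply MVT_upper_bound with G1; [lra| apply Hrc; auto| intros; apply Hd; lra|].
    intros x Hx. specialize (HG1neg x ltac:(lra)). nra. }
  destruct (MVT_cor2 g G1 (b/2) b) as [c [Hc1 Hc2]]; [lra| intros; apply Hd; lra|].
  specialize (HG1neg c ltac:(lra)).
  assert (G1 c < 0) by nra.
  specialize (Hmin b ltac:(lra)). nra.
Qed.

Lemma lim_near_0_right_nonneg : forall f l, lim_near near_0_right f l ->
  (forall c, 0 < c -> 0 <= f c) -> 0 <= l.
Proof.
  intros f l Hf Hpos. apply Rnot_lt_le; intro Hneg.
  destruct (Hf (- l / 2)) as [del [Hdel H]]; [lra|].
  specialize (H (del / 2) ltac:(red; lra)). specialize (Hpos (del / 2) ltac:(lra)).
  apply Rabs_def2 in H. lra.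
Qed.

Definition open_in (d : nat) (Om : (nat -> R) -> Prop) : Prop :=
  (forall z, Om z -> inRd d z) /\
  (forall z, Om z -> exists eps, 0 < eps /\ forall w, inRd d w -> normd d (vsub w z) < eps -> Om w).

Lemma bounded_domain_open : forall d Om, bounded_domain d Om -> open_in d Om.
Proof. intros d Om [H1 [_ [H3 _]]]. split; auto. Qed.

Lemma open_in_closure : forall d Om x, open_in d Om -> Om x -> closure d Om x.
Proof.
  intros d Om x [Hin _] Hx. split; [auto|]. intros eps He. exists x. split; auto.
  rewrite normd_vsub_self; auto.
Qed.

Definition vline (y h : nat -> R) (s : R) : nat -> R := fun j => y j + s * h j.

Lemma vline_0 : forall y h, vline y h 0 = y.
Proof. intros; apply functional_extensionality; intro; unfold vline; ring. Qed.

Lemma vline_shift : forall y h s t, vline (vline y h s) h t = vline y h (s + t).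
Proof. intros; apply functional_extensionality; intro; unfold vline; ring. Qed.

Lemma vline_vsub_1 : forall xs y, vline xs (vsub y xs) 1 = y.
Proof. intros; apply functional_extensionality; intro; unfold vline, vsub; ring. Qed.

Lemma vline_inRd : forall d y h s, inRd d y -> inRd d h -> inRd d (vline y h s).
Proof. intros d y h s Hy Hh j Hj. unfold vline. rewrite Hy, Hh by auto. ring. Qed.

Lemma l1d_vline : forall d y h s, 0 <= s -> l1d d (vsub (vline y h s) y) = s * l1d d h.
Proof.
  intros d y h s Hs. unfold l1d. rewrite <- sumd_scal. apply sumd_ext. intros i _. unfold vline, vsub.
  replace (y i + s * h i - y i) with (s * h i) by ring. rewrite Rabs_mult, (Rabs_pos_eq s); lra.
Qed.

Lemma normd_coord_bound : forall d (z y h : nat -> R) s,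
  (forall j, (j < d)%nat -> Rabs (z j - y j) <= Rabs s * Rabs (h j)) ->
  normd d (vsub z y) <= Rabs s * l1d d h.
Proof.
  intros d z y h s H. eapply Rle_trans; [apply normd_le_l1d|].
  unfold l1d. rewrite <- sumd_scal. apply sumd_le. intros i Hi. apply H; auto.
Qed.

Lemma normd_vline : forall d y h s, normd d (vsub (vline y h s) y) <= Rabs s * l1d d h.
Proof.
  intros. apply normd_coord_bound. intros j Hj. unfold vline.
  replace (y j + s * h j - y j) with (s * h j) by ring. rewrite Rabs_mult; lra.
Qed.

Lemma open_line_enters : forall d Om xs h, open_in d Om -> Om xs -> inRd d h ->
  exists s0, 0 < s0 /\ forall s, 0 < s < s0 -> Om (vline xs h s).
Proof.
  intros d Om xs h [Hin Hop] Hxs Hh. destruct (Hop xs Hxs) as [rho [Hrho Hb]].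
  pose proof (l1d_nonneg d h).
  exists (rho / (l1d d h + 1)). split; [apply Rdiv_lt_0_compat; lra|]. intros s Hs.
  apply Hb; [apply vline_inRd; auto|].
  eapply Rle_lt_trans; [apply normd_vline|]. rewrite Rabs_pos_eq by lra.
  assert (s * (l1d d h + 1) < rho).
  { destruct Hs as [_ Hs]. apply Rmult_lt_compat_r with (r := l1d d h + 1) in Hs; [|lra].
    field_simplify in Hs; lra. }
  nra.
Qed.

(** The l^1 balls are used as convex open neighbourhoods. *)
Definition ball_l1 d (xs : nat -> R) rho : (nat -> R) -> Prop := fun y => inRd d y /\ l1d d (vsub y xs) < rho.

Lemma ball_l1_open : forall d xs rho, open_in d (ball_l1 d xs rho).
Proof.
  intros d xs rho. split; [intros z [Hz _]; auto|].
  intros z [Hz Hzr]. set (sg := rho - l1d d (vsub z xs)).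
  pose proof (pos_INR d).
  exists (sg / (INR d + 1)). split; [apply Rdiv_lt_0_compat; unfold sg; lra|].
  intros w Hw Hn. split; auto.
  pose proof (l1d_triang d w z xs). pose proof (l1d_le_normd d (vsub w z)).
  pose proof (normd_nonneg d (vsub w z)).
  assert (INR d * normd d (vsub w z) < sg).
  { apply Rlt_le_trans with ((INR d + 1) * (sg / (INR d + 1))); [nra|]. right; field; lra. }
  unfold sg in *. lra.
Qed.

Section ChainRule.

Variables (d : nat) (Om : (nat -> R) -> Prop) (f : (nat -> R) -> R) (g : nat -> (nat -> R) -> R).
Variables (y h : nat -> R) (s e : R).
Hypothesis Hy : inRd d y.
Hypothesis Hpart : forall z i, Om z -> (i < d)%nat -> has_partial f i z (g i z).
Hypothesis Hnear : forall z, inRd d z -> (forall j, (j < d)%nat -> Rabs (z j - y j) <= Rabs s * Rabs (h j)) ->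
  Om z /\ forall i, (i < d)%nat -> Rabs (g i z - g i y) < e.

(** Moving from [y] to [vline y h s] one coordinate at a time: [vline_part k] has moved the first [k]. *)
Definition vline_part (k : nat) : nat -> R := fun j => y j + (if Nat.ltb j k then s * h j else 0).

Lemma vline_part_step : forall k, (k < d)%nat ->
  Rabs (f (vline_part (S k)) - f (vline_part k) - s * (h k * g k y)) <= Rabs s * Rabs (h k) * e.
Proof.
  intros k Hk.
  set (q := fun c => upd (vline_part k) k c).
  assert (Hq1 : vline_part (S k) = q (y k + s * h k)).
  { apply functional_extensionality; intro j. unfold q, vline_part, upd.
    destruct (Nat.eqb_spec j k) as [->|Hne].
    - replace (Nat.ltb k (S k)) with true by (symmetry; apply Nat.ltb_lt; lia). reflexivity.
    - destruct (Nat.ltb_spec j (S k)); destruct (Nat.ltb_spec j k); try reflexivity; lia. }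
  assert (Hq0 : vline_part k = q (y k)).
  { apply functional_extensionality; intro j. unfold q, vline_part, upd.
    destruct (Nat.eqb_spec j k) as [->|Hne]; [|reflexivity].
    replace (Nat.ltb k k) with false by (symmetry; apply Nat.ltb_ge; lia). ring. }
  assert (Hqnear : forall c, Rmin (y k) (y k + s * h k) <= c <= Rmax (y k) (y k + s * h k) ->
            Om (q c) /\ forall i, (i < d)%nat -> Rabs (g i (q c) - g i y) < e).
  { intros c Hc. apply Hnear.
    - intros j Hj. unfold q, upd, vline_part. destruct (Nat.eqb_spec j k); [lia|].
      destruct (Nat.ltb_spec j k); [lia|]. rewrite Hy by auto. ring.
    - intros j Hj. unfold q, upd, vline_part. rewrite <- Rabs_mult.
      destruct (Nat.eqb_spec j k) as [->|Hne].
      + unfold Rmin, Rmax in Hc. destruct (Rle_dec (y k) (y k + s * h k)); apply Rabs_le;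
          pose proof (Rle_abs (s * h k)); pose proof (Rle_abs (- (s * h k))); rewrite Rabs_Ropp in *; lra.
      + destruct (Nat.ltb_spec j k).
        * replace (y j + s * h j - y j) with (s * h j) by ring. lra.
        * replace (y j + 0 - y j) with 0 by ring. rewrite Rabs_R0. apply Rabs_pos. }
  destruct (MVT_between (fun c => f (q c)) (fun c => g k (q c)) (y k) (y k + s * h k)) as [c [Hc1 Hc2]].
  { intros c Hc. pose proof (Hpart (q c) k (proj1 (Hqnear c Hc)) Hk) as Hp. unfold has_partial in Hp.
    replace (q c k) with c in Hp by (unfold q, upd; rewrite Nat.eqb_refl; auto).
    eapply derivable_pt_lim_ext; [|exact Hp]. intro s'. cbv beta. f_equal.
    apply functional_extensionality; intro j. unfold q, upd. destruct (Nat.eqb j k); reflexivity. }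
  rewrite Hq1, Hq0.
  replace (y k + s * h k - y k) with (s * h k) in Hc2 by ring.
  replace (f (q (y k + s * h k)) - f (q (y k)) - s * (h k * g k y))
    with ((s * h k) * (g k (q c) - g k y)) by lra.
  rewrite !Rabs_mult. apply Rmult_le_compat_l; [apply Rmult_le_pos; apply Rabs_pos|].
  left. apply (proj2 (Hqnear c Hc1)); auto.
Qed.

Lemma vline_part_increment : forall k, (k <= d)%nat ->
  Rabs (f (vline_part k) - f y - s * sumd k (fun i => h i * g i y)) <= Rabs s * l1d k h * e.
Proof.
  induction k; intros Hk.
  - replace (vline_part 0) with y by (apply functional_extensionality; intro j; unfold vline_part; simpl; ring).
    unfold l1d, sumd; simpl. rewrite Rminus_diag, Rmult_0_r, Rminus_0_r, Rabs_R0. lra.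
  - unfold l1d in *. rewrite !sumd_S.
    replace (f (vline_part (S k)) - f y - s * (sumd k (fun i => h i * g i y) + h k * g k y))
      with ((f (vline_part k) - f y - s * sumd k (fun i => h i * g i y)) +
            (f (vline_part (S k)) - f (vline_part k) - s * (h k * g k y))) by ring.
    eapply Rle_trans; [apply Rabs_triang|].
    pose proof (IHk ltac:(lia)). pose proof (vline_part_step k ltac:(lia)). lra.
Qed.

End ChainRule.

Lemma chain_rule : forall d (Om : (nat -> R) -> Prop) (f : (nat -> R) -> R) (g : nat -> (nat -> R) -> R) y h,
  open_in d Om ->
  (forall z i, Om z -> (i < d)%nat -> has_partial f i z (g i z)) ->
  (forall i, (i < d)%nat -> forall eps, 0 < eps -> exists del, 0 < del /\
      forall z, Om z -> normd d (vsub z y) < del -> Rabs (g i z - g i y) < eps) ->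
  Om y -> inRd d h ->
  derivable_pt_lim (fun s => f (vline y h s)) 0 (sumd d (fun i => h i * g i y)).
Proof.
  intros d Om f g y h [Hin Hop] Hp Hc Hy Hh.
  set (HH := l1d d h).
  assert (HH0 : 0 <= HH) by apply l1d_nonneg.
  destruct (Hop y Hy) as [rho [Hrho Hball]].
  intros eps Heps.
  set (e := eps / (2 * (HH + 1))).
  assert (He : 0 < e) by (unfold e; apply Rdiv_lt_0_compat; lra).
  destruct (min_pos_family d (fun i del => forall z, Om z -> normd d (vsub z y) < del -> Rabs (g i z - g i y) < e))
    as [dc [Hdc Hdcp]].
  { intros i a b Ha Hab Hb z Hz Hn. apply Hb; auto; lra. }
  { intros i Hi. apply Hc; auto. }
  set (del := Rmin rho dc / (HH + 1)).
  assert (Hdel : 0 < del) by (unfold del; apply Rdiv_lt_0_compat; [apply Rmin_pos|]; lra).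
  exists (mkposreal del Hdel). intros s Hs0 Hs. simpl in Hs.
  assert (Hnear : forall z, inRd d z -> (forall j, (j < d)%nat -> Rabs (z j - y j) <= Rabs s * Rabs (h j)) ->
            Om z /\ forall i, (i < d)%nat -> Rabs (g i z - g i y) < e).
  { intros z Hz Hzb. pose proof (normd_coord_bound d z y h s Hzb) as Hn. fold HH in Hn.
    assert (Hsm : Rabs s * HH < Rmin rho dc).
    { unfold del in Hs. apply Rmult_lt_compat_r with (r := HH + 1) in Hs; [|lra].
      field_simplify in Hs; [|lra]. pose proof (Rabs_pos s). nra. }
    pose proof (Rmin_l rho dc). pose proof (Rmin_r rho dc).
    assert (Om z) by (apply Hball; auto; lra).
    split; auto. intros i Hi. apply Hdcp; auto. lra. }
  pose proof (vline_part_increment d Om f g y h s e (Hin y Hy) Hp Hnear d (le_n d)) as Hinc.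
  replace (vline_part y h s d) with (vline y h (0 + s)) in Hinc.
  2: { apply functional_extensionality; intro j. unfold vline_part, vline. destruct (Nat.ltb_spec j d); [ring|].
       rewrite (Hh j) by lia. ring. }
  rewrite vline_0. fold HH in Hinc.
  replace ((f (vline y h (0 + s)) - f y) / s - sumd d (fun i => h i * g i y))
    with ((f (vline y h (0 + s)) - f y - s * sumd d (fun i => h i * g i y)) / s) by (field; auto).
  unfold Rdiv. rewrite Rabs_mult, Rabs_inv.
  apply Rle_lt_trans with (Rabs s * HH * e * / Rabs s).
  { apply Rmult_le_compat_r; [apply Rlt_le, Rinv_0_lt_compat, Rabs_pos_lt; auto| exact Hinc]. }
  replace (Rabs s * HH * e * / Rabs s) with (HH * e) by (field; apply Rabs_no_R0; auto).
  unfold e. replace (HH * (eps / (2 * (HH + 1)))) with (eps * (HH / (2 * (HH + 1)))) by (field; lra).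
  assert (HH / (2 * (HH + 1)) < 1).
  { apply Rmult_lt_reg_r with (2 * (HH + 1)); [lra|]. field_simplify; lra. }
  nra.
Qed.

Lemma derivable_along_line : forall d (Om : (nat -> R) -> Prop) (f : (nat -> R) -> R) (g : nat -> (nat -> R) -> R) y h s,
  open_in d Om ->
  (forall z i, Om z -> (i < d)%nat -> has_partial f i z (g i z)) ->
  (forall i, (i < d)%nat -> forall z, Om z -> forall eps, 0 < eps -> exists del, 0 < del /\
      forall z', Om z' -> normd d (vsub z' z) < del -> Rabs (g i z' - g i z) < eps) ->
  Om (vline y h s) -> inRd d h ->
  derivable_pt_lim (fun t => f (vline y h t)) s (sumd d (fun i => h i * g i (vline y h s))).
Proof.
  intros d Om f g y h s Hop Hp Hc Hys Hh. apply derivable_shift.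
  apply derivable_pt_lim_ext with (fun t => f (vline (vline y h s) h t)).
  { intro t. rewrite vline_shift. reflexivity. }
  apply chain_rule with Om; auto.
Qed.

(** * Minima in space *)

Definition cont_closure d (Om : (nat -> R) -> Prop) (f : (nat -> R) -> R) : Prop :=
  forall x, closure d Om x -> forall eps, 0 < eps -> exists del, 0 < del /\
    forall y, closure d Om y -> normd d (vsub y x) < del -> Rabs (f y - f x) < eps.

Lemma cont_closure_interior : forall d Om f, open_in d Om -> cont_closure d Om f -> forall y, Om y ->
  forall eps, 0 < eps -> exists del, 0 < del /\
    forall z, Om z -> normd d (vsub z y) < del -> Rabs (f z - f y) < eps.
Proof.
  intros d Om f Hop Hf y Hy eps He. destruct (Hf y (open_in_closure d Om y Hop Hy) eps He) as [del [Hdel H]].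
  exists del; split; auto. intros z Hz Hn. apply H; auto. apply open_in_closure; auto.
Qed.

Lemma right_cont0_line : forall d Om f xs h s0, 0 < s0 -> cont_closure d Om f -> open_in d Om -> closure d Om xs ->
  (forall s, 0 < s < s0 -> Om (vline xs h s)) -> right_cont0 (fun s => f (vline xs h s)).
Proof.
  intros d Om f xs h s0 Hs0 Hf Hop Hxs Hadm eps He.
  destruct (Hf xs Hxs eps He) as [del [Hdel H]].
  set (HH := l1d d h). assert (HH0 : 0 <= HH) by apply l1d_nonneg.
  exists (Rmin s0 (del / (HH + 1))). split; [apply Rmin_pos; auto; apply Rdiv_lt_0_compat; lra|].
  intros x Hx. unfold near_0_right in Hx. rewrite vline_0.
  pose proof (Rmin_l s0 (del / (HH + 1))). pose proof (Rmin_r s0 (del / (HH + 1))).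
  apply H.
  - apply open_in_closure; auto. apply Hadm. lra.
  - eapply Rle_lt_trans; [apply normd_vline|]. fold HH. rewrite Rabs_pos_eq by lra.
    assert (Hx' : x * (HH + 1) < del).
    { assert (Hx2 : x < del / (HH + 1)) by lra.
      apply Rmult_lt_compat_r with (r := HH + 1) in Hx2; [|lra]. field_simplify in Hx2; lra. }
    nra.
Qed.

Definition hess_form d (M : nat -> nat -> R) (h : nat -> R) : R :=
  sumd d (fun a => h a * sumd d (fun b => h b * M a b)).

Lemma hess_form_unit_vec : forall d M i s, (i < d)%nat -> hess_form d M (fun j => s * unit_vec i j) = s * s * M i i.
Proof. intros. unfold hess_form. rewrite !sumd_unit_vec; auto. ring. Qed.


Section BoundaryChart.

Variables (d : nat) (Om : (nat -> R) -> Prop) (xs : nat -> R) (rho L : R).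
Variables (F : (nat -> R) -> R) (G : nat -> (nat -> R) -> R).
Hypothesis HOm_in : forall x, Om x -> inRd d x.
Hypothesis Hxs : bdry d Om xs.
Hypothesis Hrho : 0 < rho.
Hypothesis Hpar : forall y i, (inRd d y /\ normd d (vsub y xs) < rho) -> (i < d)%nat -> has_partial F i y (G i y).
Hypothesis Hlip : forall y z i, (inRd d y /\ normd d (vsub y xs) < rho) -> (inRd d z /\ normd d (vsub z xs) < rho) ->
  (i < d)%nat -> Rabs (G i y - G i z) <= L * normd d (vsub y z).
Hypothesis Hchart : forall y, (inRd d y /\ normd d (vsub y xs) < rho) -> (Om y <-> F y < 0).

(** An l^1 ball around [xs] inside the chart, on which the segment arguments take place. *)
Let B := ball_l1 d xs (rho / (INR d + 1)).

Let Hxs_in : inRd d xs.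
Proof. apply Hxs. Qed.

Lemma chart_B_in_ball : forall y, B y -> inRd d y /\ normd d (vsub y xs) < rho.
Proof.
  assert (HdI : 0 < INR d + 1) by (pose proof (pos_INR d); lra).
  intros y [Hy Hyr]. split; auto. eapply Rle_lt_trans; [apply normd_le_l1d|].
  apply Rlt_le_trans with (rho / (INR d + 1)); [exact Hyr|].
  assert (rho / (INR d + 1) * (INR d + 1) = rho) by (field; lra).
  assert (0 < rho / (INR d + 1)) by (apply Rdiv_lt_0_compat; lra). pose proof (pos_INR d). nra.
Qed.

Lemma chart_B_center : B xs.
Proof.
  assert (HdI : 0 < INR d + 1) by (pose proof (pos_INR d); lra).
  split; auto. unfold l1d. rewrite sumd_zero; [apply Rdiv_lt_0_compat; lra|].
  intros; unfold vsub; rewrite Rminus_diag, Rabs_R0; auto.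
Qed.

Lemma chart_G_cont : forall i y, (i < d)%nat -> B y -> forall eps, 0 < eps -> exists del, 0 < del /\
  forall z, B z -> normd d (vsub z y) < del -> Rabs (G i z - G i y) < eps.
Proof.
  intros i y Hi Hy eps He. pose proof (Rabs_pos L).
  exists (eps / (Rabs L + 1)). split; [apply Rdiv_lt_0_compat; lra|].
  intros z Hz Hn. eapply Rle_lt_trans; [apply Hlip; auto; apply chart_B_in_ball; auto|].
  pose proof (normd_nonneg d (vsub z y)).
  apply Rle_lt_trans with (Rabs L * normd d (vsub z y)); [apply Rmult_le_compat_r; auto; apply Rle_abs|].
  apply Rle_lt_trans with (Rabs L * (eps / (Rabs L + 1))); [apply Rmult_le_compat_l; lra|].
  apply Rmult_lt_reg_r with (Rabs L + 1); [lra|]. field_simplify; lra.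
Qed.

Lemma chart_F_segment : forall y k s, 0 <= s -> inRd d k -> (forall t, 0 <= t <= s -> B (vline y k t)) ->
  exists c, 0 <= c <= s /\ F (vline y k s) - F y = sumd d (fun j => k j * G j (vline y k c)) * s.
Proof.
  intros y k s Hs Hk HB.
  destruct (MVT_between (fun t => F (vline y k t)) (fun t => sumd d (fun j => k j * G j (vline y k t))) 0 s)
    as [c [Hc1 Hc2]].
  { intros c Hc. rewrite Rmin_left, Rmax_right in Hc by lra.
    apply derivable_along_line with B; auto; [apply ball_l1_open| |].
    - intros z i Hz Hi. apply Hpar; auto. apply chart_B_in_ball; auto.
    - intros i Hi z Hz. apply chart_G_cont; auto. }
  rewrite Rmin_left, Rmax_right in Hc1 by lra. rewrite vline_0, Rminus_0_r in Hc2. eauto.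
Qed.

Let GS := l1d d (fun j => G j xs) + Rabs L * rho.

Lemma chart_G_bound : forall j z, (j < d)%nat -> B z -> Rabs (G j z) <= GS.
Proof.
  intros j z Hj Hz. unfold GS. replace (G j z) with (G j xs + (G j z - G j xs)) by ring.
  eapply Rle_trans; [apply Rabs_triang|].
  assert (Rabs (G j xs) <= l1d d (fun j => G j xs))
    by (apply (sumd_term_le d (fun j => Rabs (G j xs))); auto; intros; apply Rabs_pos).
  assert (Rabs (G j z - G j xs) <= Rabs L * rho).
  { eapply Rle_trans; [apply Hlip; auto; apply chart_B_in_ball; auto; apply chart_B_center|].
    destruct (chart_B_in_ball z Hz) as [_ Hn].
    pose proof (normd_nonneg d (vsub z xs)). pose proof (Rabs_pos L).
    apply Rle_trans with (Rabs L * normd d (vsub z xs)); [apply Rmult_le_compat_r; auto; apply Rle_abs|].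
    apply Rmult_le_compat_l; lra. }
  lra.
Qed.

Lemma chart_F_boundary_nonpos : F xs <= 0.
Proof.
  assert (HdI : 0 < INR d + 1) by (pose proof (pos_INR d); lra).
  apply Rnot_lt_le; intro Hpos.
  assert (HGS : 0 <= GS) by (unfold GS; pose proof (l1d_nonneg d (fun j => G j xs)); pose proof (Rabs_pos L); nra).
  set (M := (GS + 1) * (INR d + 1)).
  assert (HM : 0 < M) by (unfold M; nra).
  set (e := Rmin (rho / (INR d + 1) / (INR d + 1)) (F xs / M)).
  assert (He : 0 < e) by (unfold e; apply Rmin_pos; repeat apply Rdiv_lt_0_compat; auto).
  destruct (proj2 (proj1 Hxs) e He) as [y [HOy Hny]].
  rewrite normd_sym in Hny.
  set (k := vsub y xs) in *.
  assert (Hk_in : inRd d k) by (intros j Hj; unfold k, vsub; rewrite Hxs_in, HOm_in by auto; ring).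
  assert (Hk : l1d d k < (INR d + 1) * e).
  { pose proof (l1d_le_normd d k). pose proof (pos_INR d). pose proof (normd_nonneg d k). nra. }
  assert (Hseg : forall t, 0 <= t <= 1 -> B (vline xs k t)).
  { intros t Ht. split; [apply vline_inRd; auto|]. rewrite l1d_vline by lra.
    assert (e <= rho / (INR d + 1) / (INR d + 1)) by apply Rmin_l.
    assert ((INR d + 1) * (rho / (INR d + 1) / (INR d + 1)) = rho / (INR d + 1)) by (field; lra).
    pose proof (l1d_nonneg d k). assert (l1d d k < rho / (INR d + 1)) by nra. nra. }
  assert (HFy : F y < 0).
  { apply Hchart; auto. apply chart_B_in_ball. rewrite <- (vline_vsub_1 xs y). apply Hseg. lra. }
  destruct (chart_F_segment xs k 1 ltac:(lra) Hk_in Hseg) as [c [Hc1 Hc2]].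
  unfold k in Hc2. rewrite vline_vsub_1, Rmult_1_r in Hc2. fold k in Hc2.
  assert (Habs : Rabs (sumd d (fun j => k j * G j (vline xs k c))) <= l1d d k * GS).
  { eapply Rle_trans; [apply sumd_abs|]. unfold l1d. rewrite Rmult_comm, <- sumd_scal.
    apply sumd_le. intros j Hj. rewrite Rabs_mult, Rmult_comm.
    apply Rmult_le_compat_r; [apply Rabs_pos|]. apply chart_G_bound; auto. }
  assert (l1d d k * GS < F xs).
  { assert (e <= F xs / M) by apply Rmin_r. pose proof (l1d_nonneg d k).
    assert (l1d d k <= (INR d + 1) * (F xs / M)) by nra.
    apply Rle_lt_trans with ((INR d + 1) * (F xs / M) * GS); [nra|].
    unfold M. replace ((INR d + 1) * (F xs / ((GS + 1) * (INR d + 1))) * GS)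
      with (F xs * (GS / (GS + 1))) by (field; lra).
    assert (GS / (GS + 1) < 1) by (apply Rmult_lt_reg_r with (GS + 1); [lra|]; field_simplify; lra).
    nra. }
  apply Rabs_le_bounds in Habs. lra.
Qed.

(** Since [F xs <= 0] and [F] decreases along [h] at [xs], the segment enters [{F < 0}]. *)
Lemma chart_inward_direction : forall h, inRd d h -> sumd d (fun j => h j * G j xs) < 0 ->
  exists s0, 0 < s0 /\ forall s, 0 < s < s0 -> Om (vline xs h s).
Proof.
  assert (HdI : 0 < INR d + 1) by (pose proof (pos_INR d); lra).
  intros h Hh Hneg.
  set (q := sumd d (fun j => h j * G j xs)).
  set (HH := l1d d h). assert (HH0 : 0 <= HH) by apply l1d_nonneg.
  destruct (min_pos_family d (fun j del => forall z, B z -> normd d (vsub z xs) < del ->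
                                Rabs (G j z - G j xs) < - q / (2 * (HH + 1)))) as [dg [Hdg Hdgp]].
  { intros j a b Ha Hab Hb z Hz Hn. apply Hb; auto; lra. }
  { intros j Hj. apply chart_G_cont; auto; [apply chart_B_center|]. apply Rdiv_lt_0_compat; unfold q in *; lra. }
  set (s0 := Rmin dg (rho / (INR d + 1)) / (HH + 1)).
  assert (Hs0 : 0 < s0) by (unfold s0; apply Rdiv_lt_0_compat; [apply Rmin_pos; [auto| apply Rdiv_lt_0_compat; auto]| lra]).
  exists s0. split; auto. intros s Hs.
  assert (Hsm : s * HH < Rmin dg (rho / (INR d + 1))).
  { assert (Hs' : s < s0) by lra. unfold s0 in Hs'.
    apply Rmult_lt_compat_r with (r := HH + 1) in Hs'; [|lra]. field_simplify in Hs'; [|lra]. nra. }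
  pose proof (Rmin_l dg (rho / (INR d + 1))). pose proof (Rmin_r dg (rho / (INR d + 1))).
  assert (HBl : forall t, 0 <= t <= s -> B (vline xs h t) /\ normd d (vsub (vline xs h t) xs) < dg).
  { intros t Ht. assert (t * HH <= s * HH) by nra. split; [split|].
    - apply vline_inRd; auto.
    - rewrite l1d_vline by lra. fold HH. lra.
    - eapply Rle_lt_trans; [apply normd_vline|]. fold HH. rewrite Rabs_pos_eq; lra. }
  destruct (chart_F_segment xs h s ltac:(lra) Hh (fun t Ht => proj1 (HBl t Ht))) as [c [Hc1 Hc2]].
  destruct (HBl c Hc1) as [HBc Hnc].
  assert (Hdq : sumd d (fun j => h j * G j (vline xs h c)) - q <= HH * (- q / (2 * (HH + 1)))).
  { unfold q. rewrite <- sumd_minus. eapply Rle_trans; [apply Rle_abs|]. eapply Rle_trans; [apply sumd_abs|].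
    unfold HH, l1d. rewrite Rmult_comm, <- sumd_scal. apply sumd_le. intros j Hj.
    replace (h j * G j (vline xs h c) - h j * G j xs) with (h j * (G j (vline xs h c) - G j xs)) by ring.
    rewrite Rabs_mult, Rmult_comm. apply Rmult_le_compat_r; [apply Rabs_pos|]. left. apply Hdgp; auto. }
  assert (HH * (- q / (2 * (HH + 1))) <= - q / 2).
  { replace (HH * (- q / (2 * (HH + 1)))) with ((- q / 2) * (HH / (HH + 1))) by (field; lra).
    assert (HH / (HH + 1) <= 1) by (apply Rmult_le_reg_r with (HH + 1); [lra|]; field_simplify; lra).
    assert (0 <= HH / (HH + 1)) by (apply Rmult_le_pos; [lra| apply Rlt_le, Rinv_0_lt_compat; lra]).
    assert (0 <= - q / 2) by (unfold q in *; lra). nra. }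
  assert (sumd d (fun j => h j * G j (vline xs h c)) * s < 0) by (apply Rmult_neg_pos; unfold q in *; lra).
  pose proof chart_F_boundary_nonpos.
  apply Hchart; [apply chart_B_in_ball, HBl; lra| lra].
Qed.

End BoundaryChart.

Definition tilted_dir (G : nat -> R) (i : nat) (s c : R) : nat -> R := fun j => s * unit_vec i j - c * G j.

Section MinimumConditions.

Variables (d : nat) (Om : (nat -> R) -> Prop).
Variables (w : (nat -> R) -> R) (wx : nat -> (nat -> R) -> R) (wxx : nat -> nat -> (nat -> R) -> R).
Variable xs : nat -> R.
Hypothesis Hop : open_in d Om.
Hypothesis Hpw : forall z i, Om z -> (i < d)%nat -> has_partial w i z (wx i z).
Hypothesis Hpwx : forall z i j, Om z -> (i < d)%nat -> (j < d)%nat -> has_partial (wx i) j z (wxx i j z).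
Hypothesis Cw : cont_closure d Om w.
Hypothesis Cwx : forall i, (i < d)%nat -> cont_closure d Om (wx i).
Hypothesis Cwxx : forall i j, (i < d)%nat -> (j < d)%nat -> cont_closure d Om (wxx i j).
Hypothesis Hxs : closure d Om xs.
Hypothesis Hmin : forall y, closure d Om y -> w xs <= w y.

Lemma min_along_direction : forall h, inRd d h ->
  (exists s0, 0 < s0 /\ forall s, 0 < s < s0 -> Om (vline xs h s)) ->
  0 <= sumd d (fun i => h i * wx i xs) /\
  (sumd d (fun i => h i * wx i xs) = 0 -> 0 <= hess_form d (fun a b => wxx a b xs) h).
Proof.
  intros h Hh [s0 [Hs0 Hadm]].
  set (g := fun s => w (vline xs h s)).
  set (G1 := fun s => sumd d (fun i => h i * wx i (vline xs h s))).
  set (G2 := fun s => hess_form d (fun a b => wxx a b (vline xs h s)) h).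
  pose proof near_0_right_mono as Hm.
  assert (HG1c : right_cont0 G1).
  { unfold right_cont0, G1. apply lim_near_sumd; auto. intros i Hi. apply lim_near_mult; auto.
    - apply lim_near_const.
    - apply (right_cont0_line d Om (wx i) xs h s0); auto. }
  assert (HG2c : right_cont0 G2).
  { unfold right_cont0, G2, hess_form. apply lim_near_sumd; auto. intros i Hi.
    apply lim_near_mult; auto; [apply lim_near_const|].
    apply lim_near_sumd; auto. intros j Hj. apply lim_near_mult; auto; [apply lim_near_const|].
    apply (right_cont0_line d Om (wxx i j) xs h s0); auto. }
  assert (Hgc : right_cont0 g) by (apply (right_cont0_line d Om w xs h s0); auto).
  assert (Hgm : forall s, 0 < s < s0 -> g 0 <= g s).
  { intros s Hs. unfold g. rewrite vline_0. apply Hmin. apply open_in_closure; auto. }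
  assert (Hdg : forall s, 0 < s < s0 -> derivable_pt_lim g s (G1 s)).
  { intros s Hs. apply derivable_along_line with Om; auto.
    intros i Hi. apply cont_closure_interior; auto. }
  assert (HdG1 : forall s, 0 < s < s0 -> derivable_pt_lim G1 s (G2 s)).
  { intros s Hs. apply derivable_sumd. intros i Hi.
    apply derivable_pt_lim_scal with (f := fun t => wx i (vline xs h t)).
    apply derivable_along_line with Om; auto.
    intros j Hj. apply cont_closure_interior; auto. }
  assert (E1 : G1 0 = sumd d (fun i => h i * wx i xs)) by (unfold G1; rewrite vline_0; reflexivity).
  assert (E2 : G2 0 = hess_form d (fun a b => wxx a b xs) h) by (unfold G2; rewrite vline_0; reflexivity).
  rewrite <- E1, <- E2. split.
  - apply (min_first_order g G1 s0); auto.
  - intros H0. apply (min_second_order g G1 G2 s0); auto.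
Qed.

Lemma interior_min_conditions : Om xs ->
  (forall i, (i < d)%nat -> wx i xs = 0) /\ (forall i, (i < d)%nat -> 0 <= wxx i i xs).
Proof.
  intros HO.
  assert (Hdir : forall i s, (i < d)%nat ->
            0 <= s * wx i xs /\ (s * wx i xs = 0 -> 0 <= s * s * wxx i i xs)).
  { intros i s Hi. assert (Hh : inRd d (fun j => s * unit_vec i j)).
    { intros j Hj. rewrite (unit_vec_inRd d i Hi j Hj). ring. }
    destruct (min_along_direction _ Hh (open_line_enters d Om xs _ Hop HO Hh)) as [H1 H2].
    rewrite sumd_unit_vec in H1, H2 by auto. rewrite hess_form_unit_vec in H2 by auto. auto. }
  assert (Hgrad : forall i, (i < d)%nat -> wx i xs = 0).
  { intros i Hi. pose proof (proj1 (Hdir i 1 Hi)). pose proof (proj1 (Hdir i (-1) Hi)). lra. }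
  split; auto. intros i Hi. pose proof (proj2 (Hdir i 1 Hi)). rewrite Hgrad in H by auto. lra.
Qed.
(** The gradient [G] of the chart is normal to the boundary, so by the Neumann condition
    [G . grad w = 0]; a direction [s e_i - c G] with negative slope along [G] points into [Om]. *)
Lemma boundary_tilted_directions : forall n, C11_boundary_normal d Om n -> bdry d Om xs ->
  sumd d (fun i => wx i xs * n xs i) = 0 ->
  exists G : nat -> R, 0 < sumd d (fun j => G j * G j) /\
    forall i s c, (i < d)%nat -> s * G i - c * sumd d (fun j => G j * G j) < 0 ->
      0 <= s * wx i xs /\ (s * wx i xs = 0 -> 0 <= hess_form d (fun a b => wxx a b xs) (tilted_dir G i s c)).
Proof.
  intros n Hn Hbd Hneu.
  destruct (Hn xs Hbd) as [rho [F [G [L [Hrho Hch]]]]]. cbv zeta in Hch.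
  destruct Hch as [Hpar [Hlip [Hpos [HOF Hnorm]]]].
  assert (HBxs : inRd d xs /\ normd d (vsub xs xs) < rho) by (split; [apply Hxs| rewrite normd_vsub_self; auto]).
  set (Gn := normd d (fun j => G j xs)).
  assert (HGn : 0 < Gn) by (apply Hpos; auto).
  set (Gv := fun j => if Nat.ltb j d then G j xs else 0).
  assert (HGvi : forall j, (j < d)%nat -> Gv j = G j xs)
    by (intros j Hj; unfold Gv; destruct (Nat.ltb_spec j d); [auto|lia]).
  assert (HGv : forall f, sumd d (fun j => Gv j * f j) = sumd d (fun j => G j xs * f j))
    by (intros f; apply sumd_ext; intros j Hj; rewrite HGvi; auto).
  assert (HGG : sumd d (fun j => Gv j * Gv j) = sumd d (fun j => G j xs * G j xs))
    by (apply sumd_ext; intros j Hj; rewrite HGvi; auto).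
  exists Gv. split.
  { rewrite HGG. assert (0 <= sumd d (fun j => G j xs * G j xs)) by (apply sumd_nonneg; intros; nra).
    destruct (Req_dec (sumd d (fun j => G j xs * G j xs)) 0) as [E|]; [|lra].
    unfold Gn, normd in HGn. rewrite E, sqrt_0 in HGn. lra. }
  assert (HGw : sumd d (fun j => G j xs * wx j xs) = 0).
  { assert (E : sumd d (fun i => wx i xs * n xs i) = / Gn * sumd d (fun j => G j xs * wx j xs)).
    { rewrite <- sumd_scal. apply sumd_ext. intros i Hi. rewrite (Hnorm xs HBxs Hbd i Hi). fold Gn.
      unfold Rdiv. ring. }
    rewrite E in Hneu. apply Rmult_integral in Hneu. destruct Hneu as [H|H]; auto.
    exfalso. apply Rinv_neq_0_compat in H; auto; lra. }
  assert (Hdir_dot : forall i s c f, (i < d)%nat ->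
            sumd d (fun j => tilted_dir Gv i s c j * f j) = s * f i - c * sumd d (fun j => G j xs * f j)).
  { intros i s c f Hi. rewrite <- (sumd_unit_vec d i s f Hi), <- HGv, <- sumd_scal, <- sumd_minus.
    apply sumd_ext. intros j Hj. unfold tilted_dir. ring. }
  intros i s c Hi Hneg.
  assert (Hdir_in : inRd d (tilted_dir Gv i s c)).
  { intros j Hj. unfold tilted_dir, Gv. rewrite (unit_vec_inRd d i Hi j Hj).
    destruct (Nat.ltb_spec j d); [lia| ring]. }
  assert (Hent : exists s0, 0 < s0 /\ forall t, 0 < t < s0 -> Om (vline xs (tilted_dir Gv i s c) t)).
  { apply (chart_inward_direction d Om xs rho L F G (proj1 Hop) Hbd Hrho Hpar Hlip HOF); auto.
    rewrite Hdir_dot, <- HGG, <- HGvi by auto. exact Hneg. }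
  destruct (min_along_direction _ Hdir_in Hent) as [H1 H2].
  rewrite Hdir_dot, HGw in H1, H2 by auto. split; [lra|]. intros H0. apply H2. lra.
Qed.

(** The gradient vanishes by taking [c] large and [s = +-1]; the Hessian bound comes from
    [s G_i <= 0] and every [c > 0], letting [c -> 0]. *)
Lemma boundary_min_conditions : forall n, C11_boundary_normal d Om n -> bdry d Om xs ->
  sumd d (fun i => wx i xs * n xs i) = 0 ->
  (forall i, (i < d)%nat -> wx i xs = 0) /\ (forall i, (i < d)%nat -> 0 <= wxx i i xs).
Proof.
  intros n Hn Hbd Hneu.
  destruct (boundary_tilted_directions n Hn Hbd Hneu) as [G [HS2 Hdir]].
  set (S2 := sumd d (fun j => G j * G j)) in *.
  assert (Hgrad : forall i, (i < d)%nat -> wx i xs = 0).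
  { intros i Hi. set (c := (Rabs (G i) + 1) / S2).
    assert (HcS : c * S2 = Rabs (G i) + 1) by (unfold c; field; lra).
    pose proof (Rle_abs (G i)). pose proof (Rle_abs (- G i)). rewrite Rabs_Ropp in *.
    pose proof (proj1 (Hdir i 1 c Hi ltac:(lra))). pose proof (proj1 (Hdir i (-1) c Hi ltac:(lra))). lra. }
  split; auto. intros i Hi.
  set (s := if Rle_dec (G i) 0 then 1 else -1).
  assert (Hs2 : s * s = 1) by (unfold s; destruct (Rle_dec (G i) 0); ring).
  assert (HsG : s * G i <= 0) by (unfold s; destruct (Rle_dec (G i) 0); lra).
  assert (Hlim : lim_near near_0_right (fun c => hess_form d (fun a b => wxx a b xs) (tilted_dir G i s c))
                   (hess_form d (fun a b => wxx a b xs) (tilted_dir G i s 0))).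
  { pose proof near_0_right_mono as Hm.
    assert (Hdirc : forall j, lim_near near_0_right (fun c => tilted_dir G i s c j) (tilted_dir G i s 0 j)).
    { intros j. unfold tilted_dir. apply lim_near_minus; auto; [apply lim_near_const|].
      apply lim_near_mult; auto; [apply lim_near_id| apply lim_near_const]. }
    unfold hess_form. apply lim_near_sumd; auto. intros a Ha. apply lim_near_mult; auto.
    apply lim_near_sumd; auto. intros b Hb. apply lim_near_mult; auto. apply lim_near_const. }
  replace (tilted_dir G i s 0) with (fun j => s * unit_vec i j) in Hlim
    by (apply functional_extensionality; intro; unfold tilted_dir; ring).
  rewrite hess_form_unit_vec, Hs2, Rmult_1_l in Hlim by auto.
  apply (lim_near_0_right_nonneg _ _ Hlim). intros c Hc.
  apply (Hdir i s c Hi); [nra|]. rewrite Hgrad by auto. ring.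
Qed.

Lemma spatial_min_conditions : forall n, C11_boundary_normal d Om n ->
  (bdry d Om xs -> sumd d (fun i => wx i xs * n xs i) = 0) ->
  (forall i, (i < d)%nat -> wx i xs = 0) /\ 0 <= sumd d (fun i => wxx i i xs).
Proof.
  intros n Hn Hneu.
  assert (Hcond : (forall i, (i < d)%nat -> wx i xs = 0) /\ (forall i, (i < d)%nat -> 0 <= wxx i i xs)).
  { destruct (classic (Om xs)) as [HO|HnO].
    - apply interior_min_conditions; auto.
    - assert (Hbd : bdry d Om xs) by (split; auto).
      apply (boundary_min_conditions n); auto. }
  destruct Hcond as [Hgrad Hlap]. split; auto. apply sumd_nonneg; auto.
Qed.

End MinimumConditions.

(** * Compactness of [[0, T] x closure Om] *)

Definition strict_incr (phi : nat -> nat) : Prop := forall n, (phi n < phi (S n))%nat.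

Lemma strict_incr_ge : forall phi, strict_incr phi -> forall n, (n <= phi n)%nat.
Proof. intros phi H n. induction n; [lia|]. specialize (H n). lia. Qed.

Lemma strict_incr_mono : forall phi, strict_incr phi -> forall n m, (n <= m)%nat -> (phi n <= phi m)%nat.
Proof. intros phi H n m Hnm. induction Hnm; [lia|]. specialize (H m). lia. Qed.

Lemma strict_incr_comp : forall phi psi, strict_incr phi -> strict_incr psi -> strict_incr (fun n => phi (psi n)).
Proof.
  intros phi psi H1 H2 n. assert (psi n < psi (S n))%nat by apply H2.
  assert (phi (S (psi n)) <= phi (psi (S n)))%nat by (apply strict_incr_mono; auto).
  specialize (H1 (psi n)). lia.
Qed.

Lemma Un_cv_subseq : forall u l psi, strict_incr psi -> Un_cv u l -> Un_cv (fun n => u (psi n)) l.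
Proof.
  intros u l psi Hp Hu eps He. destruct (Hu eps He) as [N HN]. exists N. intros n Hn.
  apply HN. pose proof (strict_incr_ge psi Hp n). lia.
Qed.

Lemma Un_cv_bounds : forall u l lo hi, Un_cv u l -> (forall n, lo <= u n <= hi) -> lo <= l <= hi.
Proof.
  intros u l lo hi Hu Hb. split; apply Rnot_lt_le; intro Hlt.
  - destruct (Hu (lo - l) ltac:(lra)) as [N HN]. specialize (HN N (le_n _)). specialize (Hb N).
    unfold R_dist in HN. apply Rabs_def2 in HN. lra.
  - destruct (Hu (l - hi) ltac:(lra)) as [N HN]. specialize (HN N (le_n _)). specialize (Hb N).
    unfold R_dist in HN. apply Rabs_def2 in HN. lra.
Qed.

(** The subsequence is built by picking, for the [k]-th term, an index beyond the previous one
    within [1/(k+1)] of the cluster point given by [Bolzano_Weierstrass]. *)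
Lemma bounded_seq_cv_subseq : forall (u : nat -> R) M, (forall n, Rabs (u n) <= M) ->
  exists phi, strict_incr phi /\ exists l, Un_cv (fun n => u (phi n)) l.
Proof.
  intros u M HM.
  destruct (Bolzano_Weierstrass u (fun c => -M <= c <= M) (compact_P3 (-M) M)) as [l Hl].
  { intros n. apply Rabs_le_bounds, HM. }
  assert (Hex : forall N k : nat, exists p, (N <= p)%nat /\ Rabs (u p - l) < / INR (S k)).
  { intros N k. assert (Hpos : 0 < / INR (S k)) by (apply Rinv_0_lt_compat, lt_0_INR; lia).
    destruct (Hl (fun y => Rabs (y - l) < / INR (S k)) N) as [p [Hp HV]].
    { exists (mkposreal _ Hpos). intros y Hy. unfold disc in Hy. simpl in Hy. auto. }
    exists p; auto. }
  set (pk := fun N k => proj1_sig (constructive_indefinite_description _ (Hex N k))).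
  assert (Hpk : forall N k, (N <= pk N k)%nat /\ Rabs (u (pk N k) - l) < / INR (S k)).
  { intros N k. unfold pk. destruct (constructive_indefinite_description _ (Hex N k)); auto. }
  set (phi := fix phi n := match n with O => pk O O | S m => pk (S (phi m)) (S m) end).
  exists phi. split.
  - intros n. simpl. destruct (Hpk (S (phi n)) (S n)). lia.
  - exists l. intros eps He. destruct (archimed_cor1 eps He) as [N [HN HN0]].
    exists N. intros n Hn. unfold R_dist.
    assert (Rabs (u (phi n) - l) < / INR (S n)) by (destruct n; simpl; apply Hpk).
    eapply Rlt_trans; [apply H|]. eapply Rle_lt_trans; [|apply HN].
    apply Rinv_le_contravar; [apply lt_0_INR; lia| apply le_INR; lia].
Qed.

Lemma bounded_seq_cv_subseq_k : forall k (z : nat -> nat -> R) M,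
  (forall n i, (i < k)%nat -> Rabs (z n i) <= M) ->
  exists phi Z, strict_incr phi /\ forall i, (i < k)%nat -> Un_cv (fun n => z (phi n) i) (Z i).
Proof.
  induction k; intros z M HM.
  - exists (fun n => n), (fun _ => 0). split; [intro; lia| intros; lia].
  - destruct (IHk z M) as [phi1 [Z1 [Hp1 Hc1]]]; [intros; apply HM; lia|].
    destruct (bounded_seq_cv_subseq (fun n => z (phi1 n) k) M) as [phi2 [Hp2 [l Hl]]]; [intros; apply HM; lia|].
    exists (fun n => phi1 (phi2 n)), (fun i => if Nat.eqb i k then l else Z1 i).
    split; [apply strict_incr_comp; auto|].
    intros i Hi. destruct (Nat.eqb_spec i k) as [->|Hne]; auto.
    apply (Un_cv_subseq (fun n => z (phi1 n) i)); auto. apply Hc1. lia.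
Qed.

Lemma closure_coord_bound : forall d Om M x, (forall y, Om y -> normd d y <= M) -> closure d Om x ->
  forall i, (i < d)%nat -> Rabs (x i) <= M + 1.
Proof.
  intros d Om M x HM [Hin Hc] i Hi. destruct (Hc 1 Rlt_0_1) as [y [Hy Hn]].
  replace (x i) with ((x i - y i) + y i) by ring. eapply Rle_trans; [apply Rabs_triang|].
  pose proof (coord_le_normd d (vsub x y) i Hi). pose proof (coord_le_normd d y i Hi).
  specialize (HM y Hy). unfold vsub in *. lra.
Qed.

Definition seq_cv_tx d (tn : nat -> R) (xn : nat -> nat -> R) (t : R) (X : nat -> R) : Prop :=
  forall eps, 0 < eps -> exists N, forall n, (N <= n)%nat -> Rabs (tn n - t) + normd d (vsub (xn n) X) < eps.

Lemma cQ_closed : forall d T Om tn xn t X, inRd d X -> (forall n, cQ d T Om (tn n) (xn n)) ->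
  seq_cv_tx d tn xn t X -> cQ d T Om t X.
Proof.
  intros d T Om tn xn t X HX Hc Hcv. pose proof (pos_INR d). split.
  - assert (Ht : forall eps, 0 < eps -> - eps < t < T + eps).
    { intros eps He. destruct (Hcv eps He) as [N HN]. specialize (HN N (le_n _)).
      pose proof (normd_nonneg d (vsub (xn N) X)). destruct (Hc N) as [Htt _].
      assert (Hlt : Rabs (tn N - t) < eps) by lra. apply Rabs_def2 in Hlt. lra. }
    split; apply Rnot_lt_le; intro Hlt; [destruct (Ht (- t / 2))| destruct (Ht ((t - T) / 2))]; lra.
  - split; auto. intros eps He.
    set (e := eps / 2 / (INR d + 1)).
    assert (He' : 0 < e) by (unfold e; apply Rdiv_lt_0_compat; lra).
    destruct (Hcv e He') as [N HN]. specialize (HN N (le_n _)).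
    destruct (Hc N) as [_ [_ Hcl]]. destruct (Hcl e He') as [y [Hy Hny]].
    exists y. split; auto.
    eapply Rle_lt_trans; [apply normd_le_l1d|].
    eapply Rle_lt_trans; [apply (l1d_triang d X (xn N) y)|].
    pose proof (l1d_le_normd d (vsub X (xn N))). pose proof (l1d_le_normd d (vsub (xn N) y)).
    rewrite normd_sym in HN. pose proof (Rabs_pos (tn N - t)).
    pose proof (normd_nonneg d (vsub X (xn N))). pose proof (normd_nonneg d (vsub (xn N) y)).
    assert (INR d * normd d (vsub X (xn N)) <= INR d * e) by (apply Rmult_le_compat_l; lra).
    assert (INR d * normd d (vsub (xn N) y) <= INR d * e) by (apply Rmult_le_compat_l; lra).
    assert (INR d * e + INR d * e < eps) by (unfold e; apply Rmult_lt_reg_r with (INR d + 1); [lra|]; field_simplify; lra).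
    lra.
Qed.

Lemma cQ_seq_compact : forall d T Om (tn : nat -> R) (xn : nat -> nat -> R),
  bounded_domain d Om -> (forall n, cQ d T Om (tn n) (xn n)) ->
  exists phi t X, strict_incr phi /\ cQ d T Om t X /\ seq_cv_tx d (fun n => tn (phi n)) (fun n => xn (phi n)) t X.
Proof.
  intros d T Om tn xn HOm Hc.
  destruct HOm as [HOin [[y0 Hy0] [_ [_ [M HM]]]]].
  assert (HM0 : 0 <= M) by (pose proof (HM y0 Hy0); pose proof (normd_nonneg d y0); lra).
  set (z := fun n i => match i with O => tn n | S j => xn n j end).
  destruct (bounded_seq_cv_subseq_k (S d) z (T + M + 1)) as [phi [Z [Hphi Hlim]]].
  { intros n i Hi. destruct (Hc n) as [Ht Hx]. destruct i; simpl.
    - rewrite Rabs_pos_eq; lra.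
    - pose proof (closure_coord_bound d Om M (xn n) HM Hx i ltac:(lia)). lra. }
  set (X := fun j => if Nat.ltb j d then Z (S j) else 0).
  assert (HX : inRd d X) by (intros j Hj; unfold X; destruct (Nat.ltb_spec j d); [lia|auto]).
  assert (Hconv : seq_cv_tx d (fun n => tn (phi n)) (fun n => xn (phi n)) (Z O) X).
  { intros eps He.
    destruct (max_index_family (S d) (fun i n => Rabs (z (phi n) i - Z i) < eps / 2 / INR (S d))) as [N HN].
    { intros i Hi. destruct (Hlim i Hi (eps / 2 / INR (S d))) as [N HN].
      { apply Rdiv_lt_0_compat; [lra| apply lt_0_INR; lia]. }
      exists N. intros n Hn. apply HN; auto. }
    exists N. intros n Hn.
    assert (H1 : Rabs (tn (phi n) - Z O) < eps / 2 / INR (S d)) by (apply (HN O); lia).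
    assert (H2 : normd d (vsub (xn (phi n)) X) < eps / 2).
    { apply normd_small; [lra|]. intros i Hi. unfold vsub, X.
      destruct (Nat.ltb_spec i d); [|lia]. apply (HN (S i)); lia. }
    assert (eps / 2 / INR (S d) <= eps / 2).
    { unfold Rdiv. rewrite <- (Rmult_1_r (eps * / 2)) at 2. apply Rmult_le_compat_l; [lra|].
      rewrite <- Rinv_1. apply Rinv_le_contravar; [lra|]. rewrite S_INR. pose proof (pos_INR d). lra. }
    lra. }
  exists phi, (Z O), X. split; auto. split; auto.
  apply (cQ_closed d T Om (fun n => tn (phi n)) (fun n => xn (phi n))); auto.
Qed.

Lemma cont2_bounded_below : forall d T Om f, bounded_domain d Om -> cont2_on d (cQ d T Om) f ->
  exists m, forall t x, cQ d T Om t x -> m <= f t x.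
Proof.
  intros d T Om f HOm Hf. apply NNPP; intro Hn.
  assert (Hs : forall n : nat, exists p : R * (nat -> R), cQ d T Om (fst p) (snd p) /\ f (fst p) (snd p) < - INR n).
  { intros n. apply NNPP; intro Hn2. apply Hn. exists (- INR n). intros t x Hc.
    apply Rnot_lt_le; intro Hlt. apply Hn2. exists (t, x). simpl; auto. }
  set (p := fun n => proj1_sig (constructive_indefinite_description _ (Hs n))).
  assert (Hp : forall n, cQ d T Om (fst (p n)) (snd (p n)) /\ f (fst (p n)) (snd (p n)) < - INR n).
  { intros n. unfold p. destruct (constructive_indefinite_description _ (Hs n)); auto. }
  destruct (cQ_seq_compact d T Om (fun n => fst (p n)) (fun n => snd (p n)) HOm (fun n => proj1 (Hp n)))
    as [phi [t [X [Hphi [HcX Hcv]]]]].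
  destruct (Hf t X HcX 1 Rlt_0_1) as [del [Hdel Hd]].
  destruct (Hcv del Hdel) as [N HN].
  destruct (INR_archimed 1 (Rabs (f t X) + 1) Rlt_0_1) as [K HK].
  set (n := max N K). specialize (HN n ltac:(lia)).
  specialize (Hd _ _ (proj1 (Hp (phi n))) HN). destruct (Hp (phi n)) as [_ Hlt].
  assert (INR K <= INR (phi n)) by (apply le_INR; pose proof (strict_incr_ge phi Hphi n); lia).
  apply Rabs_def2 in Hd. pose proof (Rle_abs (- f t X)). rewrite Rabs_Ropp in *. lra.
Qed.

Lemma cont2_min_attained : forall d T Om f, bounded_domain d Om -> 0 <= T -> cont2_on d (cQ d T Om) f ->
  exists t x, cQ d T Om t x /\ forall t' x', cQ d T Om t' x' -> f t x <= f t' x'.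
Proof.
  intros d T Om f HOm HT Hf.
  destruct (cont2_bounded_below d T Om f HOm Hf) as [m0 Hm0].
  set (E := fun y => exists t x, cQ d T Om t x /\ y = - f t x).
  destruct (completeness E) as [s [Hub Hlub]].
  { exists (- m0). intros y [t [x [Hc ->]]]. specialize (Hm0 t x Hc). lra. }
  { destruct HOm as [HOin [[y0 Hy0] [Hop _]]]. exists (- f 0 y0), 0, y0.
    split; auto. split; [lra|]. apply open_in_closure; auto. split; auto. }
  assert (Hge : forall t' x', cQ d T Om t' x' -> - s <= f t' x').
  { intros t' x' Hc. assert (- f t' x' <= s) by (apply Hub; exists t', x'; auto). lra. }
  assert (Hs : forall n : nat, exists p : R * (nat -> R),
            cQ d T Om (fst p) (snd p) /\ f (fst p) (snd p) < - s + / INR (S n)).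
  { intros n. apply NNPP; intro Hn.
    assert (Hb : is_upper_bound E (s - / INR (S n))).
    { intros y [t [x [Hc ->]]]. apply Rnot_lt_le; intro Hlt. apply Hn. exists (t, x). cbn [fst snd]. split; auto. lra. }
    specialize (Hlub _ Hb). assert (0 < / INR (S n)) by (apply Rinv_0_lt_compat, lt_0_INR; lia). lra. }
  set (p := fun n => proj1_sig (constructive_indefinite_description _ (Hs n))).
  assert (Hp : forall n, cQ d T Om (fst (p n)) (snd (p n)) /\ f (fst (p n)) (snd (p n)) < - s + / INR (S n)).
  { intros n. unfold p. destruct (constructive_indefinite_description _ (Hs n)); auto. }
  destruct (cQ_seq_compact d T Om (fun n => fst (p n)) (fun n => snd (p n)) HOm (fun n => proj1 (Hp n)))
    as [phi [t [X [Hphi [HcX Hcv]]]]].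
  exists t, X. split; auto. intros t' x' Hc. specialize (Hge t' x' Hc).
  enough (f t X <= - s) by lra.
  apply Rnot_lt_le; intro Hlt. set (eps := (f t X + s) / 2).
  destruct (Hf t X HcX eps ltac:(unfold eps; lra)) as [del [Hdel Hd]].
  destruct (Hcv del Hdel) as [N HN].
  destruct (archimed_cor1 eps ltac:(unfold eps; lra)) as [K [HK HK0]].
  set (n := max N K). specialize (HN n ltac:(lia)).
  specialize (Hd _ _ (proj1 (Hp (phi n))) HN). destruct (Hp (phi n)) as [_ Hlt2].
  assert (/ INR (S (phi n)) <= / INR K).
  { apply Rinv_le_contravar; [apply lt_0_INR; lia| apply le_INR]. pose proof (strict_incr_ge phi Hphi n). lia. }
  apply Rabs_def2 in Hd. unfold eps in *. lra.
Qed.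

Lemma cont2_slice : forall d T Om f t, 0 <= t <= T -> cont2_on d (cQ d T Om) f -> cont_closure d Om (fun y => f t y).
Proof.
  intros d T Om f t Ht Hf x Hx eps He. destruct (Hf t x (conj Ht Hx) eps He) as [del [Hdel H]].
  exists del. split; auto. intros y Hy Hn. apply H; [split; auto|]. rewrite Rminus_diag, Rabs_R0. lra.
Qed.

Lemma cont2_restrict : forall d T T' Om f, T' <= T -> cont2_on d (cQ d T Om) f -> cont2_on d (cQ d T' Om) f.
Proof.
  intros d T T' Om f HT Hf t x [[Ht0 Ht1] Hx] eps He.
  assert (HtT : t <= T) by lra.
  destruct (Hf t x (conj (conj Ht0 HtT) Hx) eps He) as [del [Hdel H]].
  exists del. split; auto. intros t' x' [[Ht0' Ht1'] Hx'] Hn. apply H; auto. split; auto. lra.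
Qed.

Lemma cont2_plus_time : forall d T Om f c, cont2_on d (cQ d T Om) f ->
  cont2_on d (cQ d T Om) (fun t x => f t x + c * t).
Proof.
  intros d T Om f c Hf t x Hc e He. pose proof (Rabs_pos c).
  destruct (Hf t x Hc (e/2)) as [d1 [Hd1 H1]]; [lra|].
  exists (Rmin d1 (e / 2 / (Rabs c + 1))). split; [apply Rmin_pos; auto; apply Rdiv_lt_0_compat; lra|].
  intros t' x' Hc' Hdist. pose proof (Rmin_l d1 (e / 2 / (Rabs c + 1))). pose proof (Rmin_r d1 (e / 2 / (Rabs c + 1))).
  pose proof (Rabs_pos (t' - t)). pose proof (normd_nonneg d (vsub x' x)).
  specialize (H1 t' x' Hc' ltac:(lra)).
  replace (f t' x' + c * t' - (f t x + c * t)) with ((f t' x' - f t x) + c * (t' - t)) by ring.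
  eapply Rle_lt_trans; [apply Rabs_triang|]. rewrite Rabs_mult.
  assert (Rabs c * Rabs (t' - t) <= e / 2).
  { apply Rle_trans with (Rabs c * (e / 2 / (Rabs c + 1))); [apply Rmult_le_compat_l; lra|].
    apply Rmult_le_reg_r with (Rabs c + 1); [lra|]. field_simplify; [|lra]. nra. }
  lra.
Qed.

Lemma cont_closure_lower_bound : forall d Om (f : (nat -> R) -> R) xs c, open_in d Om -> closure d Om xs ->
  cont_closure d Om f -> (exists del, 0 < del /\ forall y, Om y -> normd d (vsub y xs) < del -> c <= f y) ->
  c <= f xs.
Proof.
  intros d Om f xs c Hop Hxs Hc [del [Hdel Hge]]. apply Rnot_lt_le; intro Hlt.
  destruct (Hc xs Hxs (c - f xs) ltac:(lra)) as [del2 [Hdel2 H2]].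
  destruct (proj2 Hxs (Rmin del del2) (Rmin_pos _ _ Hdel Hdel2)) as [y [Hy Hn]].
  rewrite normd_sym in Hn. pose proof (Rmin_l del del2). pose proof (Rmin_r del del2).
  specialize (Hge y Hy ltac:(lra)). specialize (H2 y (open_in_closure d Om y Hop Hy) ltac:(lra)).
  apply Rabs_def2 in H2. lra.
Qed.

Lemma time_derivative_at_min : forall d T Om (u ut : R -> (nat -> R) -> R) ts xs,
  open_in d Om -> 0 < ts <= T -> closure d Om xs ->
  cont2_on d (cQ d T Om) u -> cont2_on d (cQ d T Om) ut ->
  (forall t y, 0 < t <= ts -> Om y -> derivable_pt_lim (fun s => u s y) t (ut t y)) ->
  (forall t y, 0 <= t <= ts -> closure d Om y -> u ts xs <= u t y) ->
  ut ts xs <= 0.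
Proof.
  intros d T Om u ut ts xs Hop Hts Hxs Cu Cut Hder Hmin.
  apply Rnot_lt_le; intro Hlt. set (eta := ut ts xs / 2).
  assert (HcQ : cQ d T Om ts xs) by (split; [lra|auto]).
  destruct (Cut ts xs HcQ eta ltac:(unfold eta; lra)) as [d1 [Hd1 H1]].
  set (h := Rmin (d1 / 2) (ts / 2)).
  assert (Hh : 0 < h) by (unfold h; apply Rmin_pos; lra).
  assert (Hh1 : h <= d1 / 2) by apply Rmin_l. assert (Hh2 : h <= ts / 2) by apply Rmin_r.
  assert (Hge : h * eta <= u ts xs - u (ts - h) xs).
  { apply (cont_closure_lower_bound d Om (fun y => u ts y - u (ts - h) y)); auto.
    - intros x Hx e He.
      destruct (cont2_slice d T Om u ts ltac:(lra) Cu x Hx (e/2)) as [e1 [He1 Hu1]]; [lra|].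
      destruct (cont2_slice d T Om u (ts - h) ltac:(lra) Cu x Hx (e/2)) as [e2 [He2 Hu2]]; [lra|].
      exists (Rmin e1 e2). split; [apply Rmin_pos; auto|]. intros y Hy Hny.
      pose proof (Rmin_l e1 e2). pose proof (Rmin_r e1 e2).
      specialize (Hu1 y Hy ltac:(lra)). specialize (Hu2 y Hy ltac:(lra)).
      apply Rabs_def2 in Hu1. apply Rabs_def2 in Hu2. apply Rabs_def1; lra.
    - exists (d1 / 2). split; [lra|]. intros y Hy Hny.
      destruct (MVT_cor2 (fun s => u s y) (fun s => ut s y) (ts - h) ts) as [c [Hc1 Hc2]]; [lra| |].
      { intros c Hc. apply Hder; auto. lra. }
      assert (Hwc : Rabs (ut c y - ut ts xs) < eta).
      { apply H1; [split; [lra| apply open_in_closure; auto]|].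
        rewrite Rabs_left by lra. lra. }
      apply Rabs_def2 in Hwc. unfold eta in *.
      replace (ts - (ts - h)) with h in Hc2 by ring. nra. }
  assert (u ts xs <= u (ts - h) xs) by (apply Hmin; auto; lra).
  unfold eta in Hge. nra.
Qed.

(** * The parabolic minimum principle *)

Definition transport_diffusion d (v : nat -> R -> (nat -> R) -> R) (a : R) (wt : R -> (nat -> R) -> R)
    (wx : nat -> R -> (nat -> R) -> R) (wxx : nat -> nat -> R -> (nat -> R) -> R) (t : R) (x : nat -> R) : R :=
  wt t x + sumd d (fun i => v i t x * wx i t x) - a * sumd d (fun i => wxx i i t x).

Definition near2 d T Om (t : R) (x : nat -> R) : R -> R * (nat -> R) -> Prop :=
  fun del p => cQ d T Om (fst p) (snd p) /\ Rabs (fst p - t) + normd d (vsub (snd p) x) < del.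

Lemma near2_mono : forall d T Om t x, near_mono (near2 d T Om t x).
Proof. intros d T Om t x a b p Ha Hab [H1 H2]. split; auto. lra. Qed.

Lemma cont2_lim_near : forall d T Om f, cont2_on d (cQ d T Om) f <->
  forall t x, cQ d T Om t x -> lim_near (near2 d T Om t x) (fun p => f (fst p) (snd p)) (f t x).
Proof.
  intros d T Om f. split.
  - intros Hf t x Hc eps He. destruct (Hf t x Hc eps He) as [del [Hdel H]].
    exists del. split; auto. intros [t' x'] [H1 H2]. simpl in *. apply H; auto.
  - intros H t x Hc eps He. destruct (H t x Hc eps He) as [del [Hdel H']].
    exists del. split; auto. intros t' x' Hc' Hn. apply (H' (t', x')). split; auto.
Qed.

Lemma cont2_transport_diffusion : forall d T Om v a wt wx wxx,
  (forall i, (i < d)%nat -> cont2_on d (cQ d T Om) (v i)) -> cont2_on d (cQ d T Om) wt ->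
  (forall i, (i < d)%nat -> cont2_on d (cQ d T Om) (wx i)) ->
  (forall i, (i < d)%nat -> cont2_on d (cQ d T Om) (wxx i i)) ->
  cont2_on d (cQ d T Om) (transport_diffusion d v a wt wx wxx).
Proof.
  intros d T Om v a wt wx wxx Hv Hwt Hwx Hwxx. apply cont2_lim_near. intros t x Hc.
  pose proof (near2_mono d T Om t x) as Hm.
  assert (Hlim : forall f, cont2_on d (cQ d T Om) f -> lim_near (near2 d T Om t x) (fun p => f (fst p) (snd p)) (f t x))
    by (intros f Hf; apply cont2_lim_near; auto).
  unfold transport_diffusion. apply lim_near_minus; auto.
  - apply lim_near_plus; auto.
    apply (lim_near_sumd _ _ d (fun i p => v i (fst p) (snd p) * wx i (fst p) (snd p))); auto.
    intros i Hi. apply lim_near_mult; auto.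
  - apply lim_near_mult; auto; [apply lim_near_const|].
    apply (lim_near_sumd _ _ d (fun i p => wxx i i (fst p) (snd p))); auto.
Qed.

(** If [w] were negative somewhere, [w + eps t] with small [eps] would reach a negative minimum at
    some [ts > 0]; there [w_t <= - eps], [grad w = 0] and [Laplacian w >= 0] (also on the boundary,
    by the Neumann condition), so the residual would be negative, whereas it is nonnegative
    wherever [w < 0]. *)
Lemma parabolic_min_principle : forall d T Om (n : (nat -> R) -> nat -> R) (w wt : R -> (nat -> R) -> R)
  (wx : nat -> R -> (nat -> R) -> R) (wxx : nat -> nat -> R -> (nat -> R) -> R)
  (v : nat -> R -> (nat -> R) -> R) a,
  bounded_domain d Om -> C11_boundary_normal d Om n -> 0 <= a ->
  cont2_on d (cQ d T Om) w -> cont2_on d (cQ d T Om) wt ->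
  (forall i, (i < d)%nat -> cont2_on d (cQ d T Om) (wx i)) ->
  (forall i j, (i < d)%nat -> (j < d)%nat -> cont2_on d (cQ d T Om) (wxx i j)) ->
  (forall i, (i < d)%nat -> cont2_on d (cQ d T Om) (v i)) ->
  (forall t x, oQ T Om t x ->
     derivable_pt_lim (fun s => w s x) t (wt t x) /\
     (forall i, (i < d)%nat -> has_partial (fun y => w t y) i x (wx i t x)) /\
     (forall i j, (i < d)%nat -> (j < d)%nat -> has_partial (fun y => wx i t y) j x (wxx i j t x))) ->
  (forall t x, 0 < t < T -> bdry d Om x -> sumd d (fun i => wx i t x * n x i) = 0) ->
  (forall x, closure d Om x -> 0 <= w 0 x) ->
  (forall t x, oQ T Om t x -> w t x < 0 -> 0 <= transport_diffusion d v a wt wx wxx t x) ->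
  forall t x, oQ T Om t x -> 0 <= w t x.
Proof.
  intros d T Om n w wt wx wxx v a HOm Hn Ha Cw Cwt Cwx Cwxx Cv Hder Hneu Hinit Hpos t0 x0 [Ht0 HOx0].
  pose proof (bounded_domain_open d Om HOm) as Hop.
  apply Rnot_lt_le; intro Hneg.
  set (eps := - w t0 x0 / (2 * t0)).
  assert (Heps : 0 < eps) by (unfold eps; apply Rdiv_lt_0_compat; lra).
  set (u := fun t x => w t x + eps * t).
  destruct (cont2_min_attained d t0 Om u HOm ltac:(lra) (cont2_restrict d T t0 Om u ltac:(lra) (cont2_plus_time d T Om w eps Cw)))
    as [ts [xs [[Hts Hxs] Hmin]]].
  assert (Hux0 : u ts xs <= u t0 x0) by (apply Hmin; split; [lra| apply open_in_closure; auto]).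
  assert (Hu0 : u t0 x0 = w t0 x0 / 2) by (unfold u, eps; field; lra).
  assert (Hts0 : 0 < ts).
  { destruct (Rle_lt_dec ts 0) as [Hle|]; auto. replace ts with 0 in * by lra.
    specialize (Hinit xs Hxs). unfold u in Hux0, Hu0. lra. }
  assert (HcQs : cQ d T Om ts xs) by (split; [lra|auto]).
  assert (Hws : w ts xs < 0) by (unfold u in Hux0, Hu0; assert (0 < eps * ts) by (apply Rmult_lt_0_compat; lra); lra).
  assert (HoQ : forall y, Om y -> oQ T Om ts y) by (intros y Hy; split; [lra|auto]).
  assert (Hwt : wt ts xs + eps <= 0).
  { apply (time_derivative_at_min d T Om u (fun t x => wt t x + eps) ts xs); auto; try lra.
    - apply cont2_plus_time; auto.
    - intros t x Hc e He. destruct (Cwt t x Hc e He) as [del [Hdel H]]. exists del. split; auto.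
      intros t' x' Ht' Hn'. replace (wt t' x' + eps - (wt t x + eps)) with (wt t' x' - wt t x) by ring. auto.
    - intros t y Ht Hy. apply derivable_pt_lim_plus; [apply (Hder t y); split; auto; lra|].
      replace eps with (eps * 1) at 2 by ring. apply derivable_pt_lim_scal, derivable_pt_lim_id.
    - intros t y Ht Hy. apply Hmin. split; auto. lra. }
  destruct (spatial_min_conditions d Om (fun y => w ts y) (fun i y => wx i ts y) (fun i j y => wxx i j ts y) xs Hop)
    with n as [Hgrad Hlap]; auto.
  { intros z i Hz Hi. apply (Hder ts z (HoQ z Hz)); auto. }
  { intros z i j Hz Hi Hj. apply (Hder ts z (HoQ z Hz)); auto. }
  { apply (cont2_slice d T); auto; lra. }
  { intros i Hi. apply (cont2_slice d T); auto; lra. }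
  { intros i j Hi Hj. apply (cont2_slice d T); auto; lra. }
  { intros y Hy. assert (u ts xs <= u ts y) by (apply Hmin; split; [lra|auto]). unfold u in *. lra. }
  { intros Hb. apply Hneu; auto. lra. }
  assert (Hr : 0 <= transport_diffusion d v a wt wx wxx ts xs).
  { apply (cont_closure_lower_bound d Om (fun y => transport_diffusion d v a wt wx wxx ts y)); auto.
    - apply (cont2_slice d T Om _ ts); [lra|]. apply cont2_transport_diffusion; auto.
    - destruct (Cw ts xs HcQs (- w ts xs) ltac:(lra)) as [d1 [Hd1 H1]].
      exists d1. split; auto. intros y Hy Hny. apply Hpos; [apply HoQ; auto|].
      specialize (H1 ts y ltac:(split; [lra| apply open_in_closure; auto])).
      rewrite Rminus_diag, Rabs_R0 in H1. specialize (H1 ltac:(lra)). apply Rabs_def2 in H1. lra. }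
  unfold transport_diffusion in Hr. rewrite sumd_zero in Hr by (intros i Hi; rewrite Hgrad; auto; ring).
  nra.
Qed.

(** * Gauge integrals of almost everywhere nonnegative functions *)

Lemma fine_app : forall del a x b P Q, fine del a x P -> fine del x b Q -> fine del a b (P ++ Q).
Proof.
  intros del a x b P. revert a. induction P as [|[[u t] w] P IH]; intros a Q HP HQ; simpl in *.
  - subst; auto.
  - destruct HP as [H1 [H2 [H3 [H4 H5]]]]. repeat split; auto; try lra; eapply IH; eauto.
Qed.

Lemma fine_mono : forall (del del0 : R -> R) P a b, (forall t, del t <= del0 t) -> fine del a b P -> fine del0 a b P.
Proof.
  intros del del0 P. induction P as [|[[u t] w] P IH]; intros a b H HP; simpl in *; auto.
  destruct HP as [H1 [H2 [H3 [H4 H5]]]]. pose proof (H t). repeat split; try lra. eapply IH; eauto.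
Qed.

Definition iv_lo (x : R * R * R) : R := fst (fst x).
Definition iv_tag (x : R * R * R) : R := snd (fst x).
Definition iv_hi (x : R * R * R) : R := snd x.
Definition iv_len (x : R * R * R) : R := iv_hi x - iv_lo x.

Lemma fine_props : forall del P a b, fine del a b P ->
  a <= b /\ forall x, In x P -> a <= iv_lo x /\ iv_lo x <= iv_tag x <= iv_hi x /\ iv_hi x <= b /\
     iv_tag x - del (iv_tag x) < iv_lo x /\ iv_hi x < iv_tag x + del (iv_tag x).
Proof.
  intros del P. induction P as [|[[u t] w] P IH]; intros a b H; simpl in *.
  - subst. split; [lra| intros x []].
  - destruct H as [H1 [H2 [H3 [H4 H5]]]]. destruct (IH _ _ H5) as [Hwb Hall]. split; [lra|].
    intros x [<-|Hx]; unfold iv_lo, iv_tag, iv_hi; simpl.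
    + repeat split; lra.
    + destruct (Hall x Hx) as [A [B [C [D E]]]]. unfold iv_lo, iv_tag, iv_hi in *. repeat split; lra.
Qed.

Lemma cousin : forall (del : R -> R) a b, a <= b -> (forall t, a <= t <= b -> 0 < del t) ->
  exists P, fine del a b P.
Proof.
  intros del a b Hab Hdel.
  set (S := fun x => a <= x <= b /\ exists P, fine del a x P).
  destruct (completeness S) as [c [Hub Hlub]].
  { exists b. intros x [Hx _]. lra. }
  { exists a. split; [lra|]. exists nil. simpl. auto. }
  assert (Hac : a <= c) by (apply Hub; split; [lra|]; exists nil; simpl; auto).
  assert (Hcb : c <= b) by (apply Hlub; intros x [Hx _]; lra).
  assert (Hdc : 0 < del c) by (apply Hdel; lra).
  assert (Hx : exists x, S x /\ c - del c < x).
  { apply NNPP; intro Hn. assert (c <= c - del c); [|lra]. apply Hlub. intros x Hx.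
    apply Rnot_lt_le; intro Hlt. apply Hn. exists x; auto. }
  destruct Hx as [x [[Hx [P HP]] Hxc]].
  assert (Hxc2 : x <= c) by (apply Hub; split; auto; exists P; auto).
  assert (Hcc' : c <= Rmin b (c + del c / 2)) by (apply Rmin_glb; lra).
  assert (Ec : Rmin b (c + del c / 2) <= c -> Rmin b (c + del c / 2) = b).
  { intros H. destruct (Rle_dec b (c + del c / 2)).
    - rewrite Rmin_left by auto. auto.
    - rewrite Rmin_right in * by lra. lra. }
  pose proof (Rmin_l b (c + del c / 2)). pose proof (Rmin_r b (c + del c / 2)).
  set (c' := Rmin b (c + del c / 2)) in *.
  assert (Hc' : S c').
  { split; [lra|]. exists (P ++ [(x, c, c')]). apply fine_app with x; auto. simpl. repeat split; lra. }
  assert (c' <= c) by (apply Hub; auto). specialize (Ec H1).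
  destruct Hc' as [_ [Q HQ]]. rewrite Ec in HQ. eauto.
Qed.

Definition lsum {A : Type} (f : A -> R) (L : list A) : R := fold_right (fun x acc => f x + acc) 0 L.

Lemma lsum_le : forall A (f g : A -> R) L, (forall x, In x L -> f x <= g x) -> lsum f L <= lsum g L.
Proof.
  intros A f g L. induction L; simpl; intros H; [lra|].
  assert (f a <= g a) by auto. assert (lsum f L <= lsum g L) by auto. lra.
Qed.

Lemma lsum_nonneg : forall A (f : A -> R) L, (forall x, In x L -> 0 <= f x) -> 0 <= lsum f L.
Proof.
  intros A f L. induction L; simpl; intros H; [lra|].
  assert (0 <= f a) by auto. assert (0 <= lsum f L) by auto. lra.
Qed.

Lemma lsum_ext_in : forall A (f g : A -> R) L, (forall x, In x L -> f x = g x) -> lsum f L = lsum g L.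
Proof. intros A f g L. induction L; simpl; intros H; auto. rewrite H, IHL; auto. Qed.

Lemma lsum_scal : forall A (f : A -> R) c L, lsum (fun x => c * f x) L = c * lsum f L.
Proof. intros. induction L; simpl; [ring|]. rewrite IHL. ring. Qed.

Lemma lsum_opp : forall A (f : A -> R) L, lsum (fun x => - f x) L = - lsum f L.
Proof. intros. induction L; simpl; [ring|]. rewrite IHL. ring. Qed.

Lemma lsum_plus : forall A (f g : A -> R) L, lsum (fun x => f x + g x) L = lsum f L + lsum g L.
Proof. intros. induction L; simpl; [ring|]. rewrite IHL. ring. Qed.

Lemma lsum_app : forall A (f : A -> R) L1 L2, lsum f (L1 ++ L2) = lsum f L1 + lsum f L2.
Proof. intros. induction L1; simpl; [ring|]. rewrite IHL1. ring. Qed.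

Lemma lsum_term : forall A (f : A -> R) L x, In x L -> (forall y, In y L -> 0 <= f y) -> f x <= lsum f L.
Proof.
  intros A f L x Hx H. induction L as [|a L IH]; simpl in *; [destruct Hx|].
  assert (0 <= f a) by auto. assert (0 <= lsum f L) by (apply lsum_nonneg; auto).
  destruct Hx as [<-|Hx]; [lra|]. assert (f x <= lsum f L) by auto. lra.
Qed.

Lemma lsum_filter : forall A (f : A -> R) (p : A -> bool) L,
  lsum f L = lsum f (filter p L) + lsum f (filter (fun x => negb (p x)) L).
Proof. intros. induction L; simpl; [ring|]. destruct (p a); simpl; rewrite IHL; ring. Qed.

Lemma lsum_filter_zero : forall A (f : A -> R) (p : A -> bool) L,
  (forall x, p x = false -> f x = 0) -> lsum f L = lsum f (filter p L).
Proof.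
  intros. induction L; simpl; [ring|]. destruct (p a) eqn:E; simpl; rewrite IHL; auto.
  rewrite H; auto; ring.
Qed.

Lemma lsum_map_seq : forall A (F : A -> R) (G : nat -> A) K,
  lsum F (map G (seq 0 (S K))) = sum_f_R0 (fun k => F (G k)) K.
Proof.
  intros A F G K. induction K; [simpl; ring|].
  rewrite seq_S, map_app, lsum_app, IHK, tech5. simpl. ring.
Qed.

Lemma rsum_lsum : forall f P, rsum f P = lsum (fun x => f (iv_tag x) * iv_len x) P.
Proof. intros f P. induction P as [|[[u t] w] P IH]; simpl; auto. rewrite IH. reflexivity. Qed.

Definition decb (P : Prop) : bool := if excluded_middle_informative P then true else false.

Lemma decb_true : forall P, decb P = true <-> P.
Proof. intros P. unfold decb. destruct (excluded_middle_informative P); split; auto; discriminate. Qed.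

Lemma filter_nil : forall A (p : A -> bool) L, (forall x, In x L -> p x = false) -> filter p L = nil.
Proof. intros A p L. induction L; simpl; auto. intros H. rewrite H by auto. apply IHL. auto. Qed.

Lemma filter_filter_imp : forall A (p q : A -> bool) L, (forall x, p x = true -> q x = true) ->
  filter p (filter q L) = filter p L.
Proof.
  intros A p q L H. induction L; simpl; auto. destruct (q a) eqn:Eq; simpl.
  - destruct (p a); rewrite IHL; auto.
  - destruct (p a) eqn:Ep; auto. rewrite H in Eq; auto. discriminate.
Qed.

Fixpoint ivs_sorted (L : list (R * R * R)) : Prop :=
  match L with
  | nil => True
  | x :: l => (forall y, In y l -> iv_hi x <= iv_lo y) /\ ivs_sorted l
  end.

Lemma ivs_sorted_filter : forall p L, ivs_sorted L -> ivs_sorted (filter p L).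
Proof.
  intros p L. induction L; simpl; auto. intros [H1 H2]. destruct (p a); simpl; auto.
  split; auto. intros y Hy. apply filter_In in Hy. apply H1; tauto.
Qed.

Lemma fine_sorted : forall del P a b, fine del a b P -> ivs_sorted P.
Proof.
  intros del P. induction P as [|[[u t] w] P IH]; intros a b H; simpl in *; auto.
  destruct H as [_ [_ [_ [_ H5]]]]. split; [|eapply IH; eauto].
  intros y Hy. destruct (fine_props _ _ _ _ H5) as [_ Hall]. apply Hall; auto.
Qed.

Lemma ivs_sorted_total_length : forall L al be, al <= be -> ivs_sorted L ->
  (forall x, In x L -> al <= iv_lo x /\ iv_lo x <= iv_hi x /\ iv_hi x <= be) ->
  lsum iv_len L <= be - al.
Proof.
  induction L as [|x L IH]; intros al be Hab Ho H; simpl; [lra|].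
  destruct Ho as [Ho1 Ho2]. destruct (H x (or_introl eq_refl)) as [A [B C]].
  assert (lsum iv_len L <= be - iv_hi x).
  { apply IH; auto. intros y Hy. destruct (H y (or_intror Hy)) as [A' [B' C']]. split; auto. }
  unfold iv_len at 1. lra.
Qed.

Definition max_label (g : R * R * R -> nat) (L : list (R * R * R)) : nat :=
  fold_right (fun x m => max (g x) m) O L.

Lemma max_label_ge : forall g L x, In x L -> (g x <= max_label g L)%nat.
Proof.
  intros g L. induction L; simpl; intros x Hx; [destruct Hx|]. destruct Hx as [<-|Hx]; [lia|].
  specialize (IHL x Hx). lia.
Qed.

Lemma lsum_group_by_label : forall (L : list (R * R * R)) (lab : R * R * R -> nat) (M : nat) (W B : nat -> R),
  (forall m, 0 <= W m) ->
  (forall x, In x L -> (lab x <= M)%nat) ->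
  (forall m, (m <= M)%nat -> lsum iv_len (filter (fun x => Nat.eqb (lab x) m) L) <= B m) ->
  lsum (fun x => W (lab x) * iv_len x) L <= sum_f_R0 (fun m => W m * B m) M.
Proof.
  intros L lab M W B HW. revert L.
  assert (Hclass : forall m L', lsum iv_len (filter (fun x => Nat.eqb (lab x) m) L') <= B m ->
      lsum (fun x => W (lab x) * iv_len x) (filter (fun x => Nat.eqb (lab x) m) L') <= W m * B m).
  { intros m L' HB. rewrite (lsum_ext_in _ _ (fun x => W m * iv_len x)).
    - rewrite lsum_scal. apply Rmult_le_compat_l; auto.
    - intros x Hx. apply filter_In in Hx. destruct Hx as [_ Hx]. apply Nat.eqb_eq in Hx. rewrite Hx. reflexivity. }
  induction M; intros L Hlab HB.
  - rewrite (lsum_filter _ _ (fun x => Nat.eqb (lab x) 0)).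
    rewrite (filter_nil _ (fun x => negb (Nat.eqb (lab x) 0))).
    2: { intros x Hx. specialize (Hlab x Hx). replace (lab x) with 0%nat by lia. reflexivity. }
    simpl. rewrite Rplus_0_r. apply Hclass, HB; lia.
  - rewrite (lsum_filter _ _ (fun x => Nat.eqb (lab x) (S M))). simpl sum_f_R0.
    assert (H1 := Hclass (S M) L (HB (S M) (le_n _))).
    assert (H2 : lsum (fun x => W (lab x) * iv_len x) (filter (fun x => negb (Nat.eqb (lab x) (S M))) L)
                 <= sum_f_R0 (fun m => W m * B m) M).
    { apply IHM.
      - intros x Hx. apply filter_In in Hx. destruct Hx as [Hx Hne]. specialize (Hlab x Hx).
        apply Bool.negb_true_iff, Nat.eqb_neq in Hne. lia.
      - intros m Hm. rewrite filter_filter_imp; [apply HB; lia|].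
        intros x Hx. apply Nat.eqb_eq in Hx. apply Bool.negb_true_iff, Nat.eqb_neq. lia. }
    lra.
Qed.

Lemma sum_inv_pow2 : forall K, sum_f_R0 (fun k => / 2 ^ (S k)) K = 1 - / 2 ^ (S K).
Proof.
  induction K; [simpl; field|]. rewrite tech5, IHK.
  replace (2 ^ S (S K)) with (2 * 2 ^ S K) by reflexivity.
  assert (2 ^ S K <> 0) by (apply pow_nonzero; lra). field; auto.
Qed.

Lemma sum_weighted_geometric : forall eps M, 0 < eps ->
  sum_f_R0 (fun m => INR (S m) * (3 * (eps / (8 * INR (S m) * 2 ^ m)))) M <= 3 * eps / 4.
Proof.
  intros eps M Heps. rewrite (sum_eq _ (fun m => / 2 ^ (S m) * (3 * eps / 4))).
  - rewrite <- (scal_sum (fun m => / 2 ^ S m)), sum_inv_pow2.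
    assert (0 < / 2 ^ S M) by (apply Rinv_0_lt_compat, pow_lt; lra). nra.
  - intros m _. assert (0 < INR (S m)) by (apply lt_0_INR; lia). assert (2 ^ m <> 0) by (apply pow_nonzero; lra).
    replace (2 ^ S m) with (2 * 2 ^ m) by reflexivity. field. split; auto; lra.
Qed.

Definition nat_ceil (x : R) : nat := Z.to_nat (up (Rabs x)).

Lemma Rabs_le_nat_ceil : forall x, Rabs x <= INR (nat_ceil x).
Proof.
  intros x. unfold nat_ceil. destruct (archimed (Rabs x)) as [H1 _]. pose proof (Rabs_pos x).
  assert (0 <= up (Rabs x))%Z by (apply le_IZR; lra).
  rewrite INR_IZR_INZ, Z2Nat.id; auto. lra.
Qed.

Lemma null1_covers : forall (N : R -> Prop) (e : nat -> R), null 1 (fun z => N (z O)) -> (forall j, 0 < e j) ->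
  exists LO HI : nat -> nat -> R, forall j, (forall k, LO j k <= HI j k) /\
      (forall t, N t -> exists k, LO j k <= t <= HI j k) /\
      (forall K, sum_f_R0 (fun k => HI j k - LO j k) K <= e j).
Proof.
  intros N e Hnull He.
  assert (Hcov : forall j, exists LH : (nat -> nat -> R) * (nat -> nat -> R),
     (forall k i, fst LH k i <= snd LH k i) /\
     (forall z, N (z O) -> exists k, forall i, (i < 1)%nat -> fst LH k i <= z i <= snd LH k i) /\
     (forall K, sum_f_R0 (fun k => prodd 1 (fun i => snd LH k i - fst LH k i)) K <= e j)).
  { intros j. destruct (Hnull (e j) (He j)) as [lo [hi H]]. exists (lo, hi). exact H. }
  set (LH := fun j => proj1_sig (constructive_indefinite_description _ (Hcov j))).
  exists (fun j k => fst (LH j) k O), (fun j k => snd (LH j) k O). intros j.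
  unfold LH. destruct (constructive_indefinite_description _ (Hcov j)) as [[lo hi] [H1 [H2 H3]]].
  simpl. split; [|split].
  - intros k. apply H1.
  - intros t Ht. destruct (H2 (fun _ => t) Ht) as [k Hk]. exists k. apply (Hk O); lia.
  - intros K. eapply Rle_trans; [|exact (H3 K)]. apply sum_Rle. intros k _. rewrite prodd_1. simpl. lra.
Qed.

Lemma length_within_cover : forall (L : list (R * R * R)) (lab : R * R * R -> nat) (LO HI rho : nat -> R),
  ivs_sorted L -> (forall k, LO k <= HI k) -> (forall k, 0 < rho k) ->
  (forall x, In x L -> LO (lab x) - rho (lab x) <= iv_lo x /\ iv_lo x <= iv_hi x /\
                       iv_hi x <= HI (lab x) + rho (lab x)) ->
  lsum iv_len L <= sum_f_R0 (fun k => HI k - LO k + 2 * rho k) (max_label lab L).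
Proof.
  intros L lab LO HI rho Hsort HLH Hrho Hin.
  rewrite (lsum_ext_in _ _ (fun x => 1 * iv_len x)) by (intros; ring).
  rewrite (sum_eq _ (fun k => 1 * (HI k - LO k + 2 * rho k))) by (intros; ring).
  apply (lsum_group_by_label L lab (max_label lab L) (fun _ => 1)); [intros; lra| intros x Hx; apply max_label_ge; auto|].
  intros k Hk.
  replace (HI k - LO k + 2 * rho k) with ((HI k + rho k) - (LO k - rho k)) by ring.
  apply ivs_sorted_total_length; [pose proof (HLH k); pose proof (Hrho k); lra| apply ivs_sorted_filter; auto|].
  intros x Hx. apply filter_In in Hx. destruct Hx as [Hx Hk2]. apply Nat.eqb_eq in Hk2.
  rewrite <- Hk2. apply Hin; auto.
Qed.

Lemma length_within_covers : forall (L : list (R * R * R)) (lab kl : R * R * R -> nat)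
  (LO HI : nat -> nat -> R) (e : nat -> R),
  ivs_sorted L -> (forall j, 0 < e j) -> (forall j k, LO j k <= HI j k) ->
  (forall j K, sum_f_R0 (fun k => HI j k - LO j k) K <= e j) ->
  (forall x, In x L -> LO (lab x) (kl x) - e (lab x) / 2 ^ S (kl x) <= iv_lo x /\ iv_lo x <= iv_hi x /\
                       iv_hi x <= HI (lab x) (kl x) + e (lab x) / 2 ^ S (kl x)) ->
  forall m, lsum iv_len (filter (fun x => Nat.eqb (lab x) m) L) <= 3 * e m.
Proof.
  intros L lab kl LO HI e Hsort He HLH Hsum Hin m. set (Lm := filter (fun x => Nat.eqb (lab x) m) L).
  eapply Rle_trans.
  { apply (length_within_cover Lm kl (LO m) (HI m) (fun k => e m / 2 ^ S k)); auto.
    - apply ivs_sorted_filter; auto.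
    - intros k. apply Rdiv_lt_0_compat; [auto| apply pow_lt; lra].
    - intros x Hx. apply filter_In in Hx. destruct Hx as [Hx Hm]. apply Nat.eqb_eq in Hm.
      rewrite <- Hm. apply Hin; auto. }
  set (Km := max_label kl Lm).
  eapply Rle_trans; [apply (sum_Rle _ (fun k => (HI m k - LO m k) + / 2 ^ (S k) * (2 * e m)))|].
  { intros k _. unfold Rdiv. lra. }
  rewrite plus_sum, <- (scal_sum (fun k => / 2 ^ S k)), sum_inv_pow2.
  assert (0 < / 2 ^ S Km) by (apply Rinv_0_lt_compat, pow_lt; lra).
  pose proof (Hsum m Km). pose proof (He m). nra.
Qed.

Lemma rsum_lower_bound : forall f P a b (N : R -> Prop) (W : R -> R),
  (forall x, In x P -> a <= iv_lo x /\ iv_lo x <= iv_tag x <= iv_hi x /\ iv_hi x <= b) ->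
  (forall t, a <= t <= b -> N t -> - W t <= f t) -> (forall t, a <= t <= b -> ~ N t -> 0 <= f t) ->
  - lsum (fun x => W (iv_tag x) * iv_len x) (filter (fun x => decb (N (iv_tag x))) P) <= rsum f P.
Proof.
  intros f P a b N W Hprops HN Hpos.
  set (g := fun x => (if excluded_middle_informative (N (iv_tag x)) then W (iv_tag x) else 0) * iv_len x).
  rewrite (lsum_ext_in _ _ g).
  2: { intros x Hx. apply filter_In in Hx. destruct Hx as [_ Hx]. apply (proj1 (decb_true _)) in Hx. unfold g.
       destruct (excluded_middle_informative (N (iv_tag x))); [reflexivity| contradiction]. }
  rewrite <- lsum_filter_zero.
  2: { intros x Hx. unfold g, decb in *. destruct (excluded_middle_informative (N (iv_tag x))); [discriminate|ring]. }
  rewrite rsum_lsum, <- lsum_opp. apply lsum_le. intros x Hx.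
  destruct (Hprops x Hx) as [A [B C]]. assert (0 <= iv_len x) by (unfold iv_len; lra). unfold g.
  destruct (excluded_middle_informative (N (iv_tag x))) as [Hn|Hn].
  - assert (- W (iv_tag x) <= f (iv_tag x)) by (apply HN; auto; lra). nra.
  - assert (0 <= f (iv_tag x)) by (apply Hpos; [lra|auto]). nra.
Qed.

(** Refine the gauge at each point [t] of [N] so that the tagged interval fits, with slack
    [rho (j, k)], inside the [k]-th interval of a cover of [N] of total length [e j], where
    [j >= |f t|]; tags in [N] then contribute at least [- sum_j (j + 1) * 3 e j >= - 3 eps / 4]. *)
Lemma null_gauge_refinement : forall f a b (N : R -> Prop) (del0 : R -> R) eps,
  null 1 (fun z => N (z O)) -> 0 < eps -> (forall t, a <= t <= b -> 0 < del0 t) ->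
  (forall t, a <= t <= b -> ~ N t -> 0 <= f t) ->
  exists del : R -> R, (forall t, del t <= del0 t) /\ (forall t, a <= t <= b -> 0 < del t) /\
    forall P, fine del a b P -> - eps <= rsum f P.
Proof.
  intros f a b N del0 eps Hnull Heps Hdel0 Hpos.
  set (e := fun j : nat => eps / (8 * INR (S j) * 2 ^ j)).
  assert (He : forall j, 0 < e j).
  { intros j. unfold e. apply Rdiv_lt_0_compat; auto. apply Rmult_lt_0_compat; [|apply pow_lt; lra].
    apply Rmult_lt_0_compat; [lra| apply lt_0_INR; lia]. }
  destruct (null1_covers N e Hnull He) as [LO [HI HLH]].
  set (jt := fun t => nat_ceil (f t)).
  assert (Hkex : forall t, exists k, N t -> LO (jt t) k <= t <= HI (jt t) k).
  { intros t. destruct (classic (N t)) as [Hn|Hn].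
    - destruct (proj1 (proj2 (HLH (jt t))) t Hn) as [k Hk]. exists k; auto.
    - exists O; tauto. }
  set (kt := fun t => proj1_sig (constructive_indefinite_description _ (Hkex t))).
  assert (Hkt : forall t, N t -> LO (jt t) (kt t) <= t <= HI (jt t) (kt t)).
  { intros t. unfold kt. destruct (constructive_indefinite_description _ (Hkex t)); auto. }
  set (rho := fun j k => e j / 2 ^ (S k)).
  assert (Hrho : forall j k, 0 < rho j k) by (intros; unfold rho; apply Rdiv_lt_0_compat; [auto| apply pow_lt; lra]).
  exists (fun t => if excluded_middle_informative (N t) then Rmin (del0 t) (rho (jt t) (kt t)) else del0 t).
  split; [intros t; destruct (excluded_middle_informative (N t)); [apply Rmin_l|lra]|].
  split; [intros t Ht; destruct (excluded_middle_informative (N t)); [apply Rmin_pos; auto|]; apply Hdel0; auto|].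
  intros P HP. destruct (fine_props _ _ _ _ HP) as [_ Hprops].
  set (lab := fun x : R * R * R => jt (iv_tag x)).
  set (L := filter (fun x => decb (N (iv_tag x))) P).
  assert (HbadL : forall x, In x L -> In x P /\ N (iv_tag x)).
  { intros x Hx. apply filter_In in Hx. destruct Hx as [Hx Hb]. split; auto. apply decb_true; auto. }
  assert (Hlow : - lsum (fun x => INR (S (lab x)) * iv_len x) L <= rsum f P).
  { apply (rsum_lower_bound f P a b N (fun t => INR (S (jt t)))); auto.
    - intros x Hx. destruct (Hprops x Hx) as (? & ? & ? & _); auto.
    - intros t _ Hn. pose proof (Rabs_le_nat_ceil (f t)). unfold jt. rewrite S_INR.
      pose proof (Rle_abs (- f t)). rewrite Rabs_Ropp in *. lra. }
  assert (Hinner : forall m, lsum iv_len (filter (fun x => Nat.eqb (lab x) m) L) <= 3 * e m).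
  { apply (length_within_covers L lab (fun x => kt (iv_tag x)) LO HI e); auto; try apply HLH.
    - apply ivs_sorted_filter. eapply fine_sorted; eauto.
    - intros x Hx. destruct (HbadL x Hx) as [HxP HN]. destruct (Hprops x HxP) as [A [B [C [D E]]]].
      specialize (Hkt (iv_tag x) HN).
      destruct (excluded_middle_informative (N (iv_tag x))) as [_|]; [|contradiction].
      pose proof (Rmin_r (del0 (iv_tag x)) (rho (lab x) (kt (iv_tag x)))).
      unfold rho, lab in *. lra. }
  assert (Hout : lsum (fun x => INR (S (lab x)) * iv_len x) L
                 <= sum_f_R0 (fun m => INR (S m) * (3 * e m)) (max_label lab L)).
  { apply (lsum_group_by_label L lab (max_label lab L) (fun m => INR (S m)) (fun m => 3 * e m)); auto.
    - intros; apply pos_INR.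
    - intros; apply max_label_ge; auto. }
  pose proof (sum_weighted_geometric eps (max_label lab L) Heps).
  unfold e in Hout; cbv beta in Hout.
  lra.
Qed.

Lemma HKint_nonneg_ae : forall f a b I (N : R -> Prop), HKint f a b I -> null 1 (fun z => N (z O)) ->
  (forall t, a <= t <= b -> ~ N t -> 0 <= f t) -> 0 <= I.
Proof.
  intros f a b I N [Hab HK] Hnull Hpos.
  apply Rnot_lt_le; intro HIneg.
  destruct (HK (- I / 2) ltac:(lra)) as [del0 [Hdel0 Hgauge]].
  destruct (null_gauge_refinement f a b N del0 (- I / 2) Hnull ltac:(lra) Hdel0 Hpos) as [del [Hdel [Hpos_del Hlow]]].
  destruct (cousin del a b Hab Hpos_del) as [P HP].
  specialize (Hgauge P (fine_mono del del0 P a b Hdel HP)). specialize (Hlow P HP).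
  apply Rabs_def2 in Hgauge. lra.
Qed.

Lemma HKint_inf_nonneg_ae : forall f a I (N : R -> Prop), HKint_inf f a I -> null 1 (fun z => N (z O)) ->
  (forall t, a <= t -> ~ N t -> 0 <= f t) -> 0 <= I.
Proof.
  intros f a I N [Hex Hcv] Hnull Hpos. apply Rnot_lt_le; intro Hlt.
  destruct (Hcv (- I) ltac:(lra)) as [B HB].
  set (b := Rmax B a).
  destruct (Hex b (Rmax_r B a)) as [J HJ].
  specialize (HB b J (Rmax_l B a) (Rmax_r B a) HJ).
  assert (0 <= J).
  { apply (HKint_nonneg_ae f a b J N HJ Hnull). intros t Ht Hn. apply Hpos; auto; lra. }
  apply Rabs_def2 in HB. lra.
Qed.

(** * Null sets and boxes *)

Lemma null_mono : forall n (S S' : (nat -> R) -> Prop), null n S -> (forall z, S' z -> S z) -> null n S'.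
Proof.
  intros n S S' H Hs eps He. destruct (H eps He) as [lo [hi [H1 [H2 H3]]]].
  exists lo, hi. split; [exact H1|]. split; [|exact H3]. intros z Hz. apply H2; auto.
Qed.

Lemma null_empty : forall n (S : (nat -> R) -> Prop), (0 < n)%nat -> (forall z, ~ S z) -> null n S.
Proof.
  intros n S Hn HS eps He. exists (fun _ _ => 0), (fun _ _ => 0).
  split; [intros; lra|]. split; [intros z Hz; exfalso; eapply HS; eauto|].
  intros K. rewrite sum_eq_R0; [lra|]. intros k _. destruct n; [lia|]. rewrite prodd_S. ring.
Qed.

Lemma null1_False : null 1 (fun _ => False).
Proof. apply null_empty; auto. Qed.

Lemma null1_add_point : forall (N : R -> Prop) p, null 1 (fun z => N (z O)) -> null 1 (fun z => N (z O) \/ z O = p).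
Proof.
  intros N p Hn eps He. destruct (Hn eps He) as [lo [hi [H1 [H2 H3]]]].
  exists (fun k i => match k with O => p | S k' => lo k' i end).
  exists (fun k i => match k with O => p | S k' => hi k' i end).
  split; [intros [|k] i; [lra| apply H1]|]. split.
  - intros z [Hz|Hz].
    + destruct (H2 z Hz) as [k Hk]. exists (S k). auto.
    + exists O. intros i Hi. replace i with O by lia. rewrite Hz. lra.
  - intros [|K].
    + simpl. rewrite prodd_1. lra.
    + rewrite decomp_sum by lia. simpl pred. rewrite prodd_1. specialize (H3 K). lra.
Qed.

Definition indicator (lo hi x : R) : R := if excluded_middle_informative (lo <= x <= hi) then 1 else 0.

Lemma count_grid_in_interval : forall al h lo hi M, 0 < h -> lo <= hi ->
  sumd M (fun m => indicator lo hi (al + INR m * h)) <= (hi - lo) / h + 1.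
Proof.
  intros al h lo hi M Hh Hlh.
  assert (Hc : h * sumd M (fun m => indicator lo hi (al + INR m * h)) <= Rmax 0 (Rmin hi (al + (INR M - 1) * h) - lo + h)).
  { induction M.
    - unfold sumd; simpl. rewrite Rmult_0_r. apply Rmax_l.
    - rewrite sumd_S, Rmult_plus_distr_l, S_INR.
      replace (INR M + 1 - 1) with (INR M) by ring.
      unfold indicator at 2. destruct (excluded_middle_informative (lo <= al + INR M * h <= hi)) as [Hin|Hout].
      + assert (Rmin hi (al + (INR M - 1) * h) <= al + INR M * h - h) by (eapply Rle_trans; [apply Rmin_r|]; lra).
        rewrite (Rmin_right hi (al + INR M * h)), Rmax_right by lra.
        assert (Rmax 0 (Rmin hi (al + (INR M - 1) * h) - lo + h) <= al + INR M * h - lo) by (apply Rmax_lub; lra).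
        lra.
      + rewrite Rmult_0_r, Rplus_0_r. eapply Rle_trans; [exact IHM|].
        apply Rle_max_compat_l. assert (Rmin hi (al + (INR M - 1) * h) <= Rmin hi (al + INR M * h)).
        { apply Rmin_glb; [apply Rmin_l|]. eapply Rle_trans; [apply Rmin_r|]. lra. }
        lra. }
  assert (Rmax 0 (Rmin hi (al + (INR M - 1) * h) - lo + h) <= hi - lo + h).
  { apply Rmax_lub; [lra|]. pose proof (Rmin_l hi (al + (INR M - 1) * h)). lra. }
  apply Rmult_le_reg_l with h; auto. replace (h * ((hi - lo) / h + 1)) with (hi - lo + h) by (field; lra). lra.
Qed.

Lemma sumd_lsum_swap : forall A M (F : nat -> A -> R) L,
  sumd M (fun m => lsum (F m) L) = lsum (fun x => sumd M (fun m => F m x)) L.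
Proof.
  intros A M F L. induction L; simpl.
  - apply sumd_zero; auto.
  - rewrite sumd_plus, IHL. reflexivity.
Qed.

(** Sampling the covering condition on a grid of [M] points of [[al, be]]. *)
Lemma cover_1d_grid : forall (A : Type) (L : list A) (w lo hi : A -> R) al be c M,
  al < be -> (0 < M)%nat -> (forall x, In x L -> 0 <= w x) -> (forall x, In x L -> lo x <= hi x) ->
  (forall t, al <= t <= be -> c <= lsum (fun x => w x * indicator (lo x) (hi x) t) L) ->
  c * (be - al) <= lsum (fun x => w x * (hi x - lo x)) L + (be - al) / INR M * lsum w L.
Proof.
  intros A L w lo hi al be c M Hab HM Hw Hlh Hc. set (h := (be - al) / INR M).
  assert (HMp : 0 < INR M) by (apply lt_0_INR; lia).
  assert (Hh : 0 < h) by (unfold h; apply Rdiv_lt_0_compat; lra).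
  assert (Hpts : forall m, (m < M)%nat -> al <= al + INR m * h <= be).
  { intros m Hm. pose proof (pos_INR m). assert (INR m <= INR M) by (apply le_INR; lia).
    assert (INR M * h = be - al) by (unfold h; field; lra). split; nra. }
  assert (H1 : INR M * c <= lsum (fun x => w x * sumd M (fun m => indicator (lo x) (hi x) (al + INR m * h))) L).
  { rewrite <- sumd_const.
    eapply Rle_trans; [apply (sumd_le M _ (fun m => lsum (fun x => w x * indicator (lo x) (hi x) (al + INR m * h)) L))|].
    { intros m Hm. apply Hc. apply Hpts; auto. }
    rewrite sumd_lsum_swap. right. apply lsum_ext_in. intros x _. rewrite sumd_scal. reflexivity. }
  assert (H2 : lsum (fun x => w x * sumd M (fun m => indicator (lo x) (hi x) (al + INR m * h))) L <=
               / h * lsum (fun x => w x * (hi x - lo x)) L + lsum w L).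
  { rewrite <- lsum_scal, <- lsum_plus. apply lsum_le. intros x Hx.
    replace (/ h * (w x * (hi x - lo x)) + w x) with (w x * ((hi x - lo x) / h + 1)) by (field; lra).
    apply Rmult_le_compat_l; auto. apply count_grid_in_interval; auto. }
  assert (Hfin : INR M * c <= / h * lsum (fun x => w x * (hi x - lo x)) L + lsum w L) by lra.
  apply Rmult_le_compat_l with (r := h) in Hfin; [|lra].
  replace (h * (INR M * c)) with (c * (be - al)) in Hfin by (unfold h; field; lra).
  replace (h * (/ h * lsum (fun x => w x * (hi x - lo x)) L + lsum w L))
    with (lsum (fun x => w x * (hi x - lo x)) L + h * lsum w L) in Hfin by (field; lra).
  exact Hfin.
Qed.

Lemma cover_1d : forall (A : Type) (L : list A) (w lo hi : A -> R) al be c,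
  al <= be -> (forall x, In x L -> 0 <= w x) -> (forall x, In x L -> lo x <= hi x) ->
  (forall t, al <= t <= be -> c <= lsum (fun x => w x * indicator (lo x) (hi x) t) L) ->
  c * (be - al) <= lsum (fun x => w x * (hi x - lo x)) L.
Proof.
  intros A L w lo hi al be c Hab Hw Hlh Hc.
  assert (Hnn : 0 <= lsum (fun x => w x * (hi x - lo x)) L).
  { apply lsum_nonneg. intros x Hx. specialize (Hw x Hx). specialize (Hlh x Hx). nra. }
  destruct (Req_dec al be) as [<-|Hne]; [rewrite Rminus_diag, Rmult_0_r; auto|].
  set (W := lsum w L). assert (HW : 0 <= W) by (apply lsum_nonneg; auto).
  apply Rnot_lt_le; intro Hlt.
  set (gap := c * (be - al) - lsum (fun x => w x * (hi x - lo x)) L).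
  assert (Hgap : 0 < gap) by (unfold gap; lra).
  destruct (INR_archimed gap ((be - al) * W + 1) Hgap) as [M HM].
  assert (HM0 : (0 < M)%nat).
  { destruct M; [|lia]. simpl in HM. assert (0 <= (be - al) * W) by (apply Rmult_le_pos; lra). lra. }
  pose proof (cover_1d_grid A L w lo hi al be c M ltac:(lra) HM0 Hw Hlh Hc) as Hgrid. fold W in Hgrid.
  assert (HMp : 0 < INR M) by (apply lt_0_INR; lia).
  assert ((be - al) / INR M * W < gap).
  { apply Rmult_lt_reg_l with (INR M); auto.
    replace (INR M * ((be - al) / INR M * W)) with ((be - al) * W) by (field; lra). lra. }
  unfold gap in *. lra.
Qed.

Lemma lsum_filter_ind : forall A (f : A -> R) (P : A -> Prop) L,
  lsum f (filter (fun x => decb (P x)) L) = lsum (fun x => f x * (if excluded_middle_informative (P x) then 1 else 0)) L.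
Proof.
  intros. induction L; simpl; auto. unfold decb at 1.
  destruct (excluded_middle_informative (P a)); simpl; rewrite IHL; ring.
Qed.

(** Slice along the last coordinate and apply [cover_1d] to the measure of the slices. *)
Lemma finite_box_cover_volume : forall n (L : list ((nat -> R) * (nat -> R))) a b,
  (forall i, (i < n)%nat -> a i <= b i) ->
  (forall bx, In bx L -> forall i, (i < n)%nat -> fst bx i <= snd bx i) ->
  (forall z, (forall i, (i < n)%nat -> a i <= z i <= b i) ->
     exists bx, In bx L /\ forall i, (i < n)%nat -> fst bx i <= z i <= snd bx i) ->
  prodd n (fun i => b i - a i) <= lsum (fun bx => prodd n (fun i => snd bx i - fst bx i)) L.
Proof.
  induction n; intros L a b Hab Hbx Hcov.
  - destruct (Hcov (fun _ => 0)) as [bx [Hin _]]; [intros; lia|].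
    eapply Rle_trans; [|apply (lsum_term _ _ L bx Hin)]; unfold prodd; simpl; [lra|]. intros; lra.
  - rewrite prodd_S.
    rewrite (lsum_ext_in _ _ (fun bx => prodd n (fun i => snd bx i - fst bx i) * (snd bx n - fst bx n)))
      by (intros; apply prodd_S).
    apply (cover_1d _ L (fun bx => prodd n (fun i => snd bx i - fst bx i)) (fun bx => fst bx n) (fun bx => snd bx n)).
    + apply Hab; lia.
    + intros bx Hin. apply prodd_nonneg. intros i Hi. specialize (Hbx bx Hin i ltac:(lia)). lra.
    + intros bx Hin. apply Hbx; auto.
    + intros t Ht.
      replace (lsum (fun x => prodd n (fun i => snd x i - fst x i) * indicator (fst x n) (snd x n) t) L)
        with (lsum (fun x => prodd n (fun i => snd x i - fst x i)) (filter (fun x => decb (fst x n <= t <= snd x n)) L))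
        by (rewrite lsum_filter_ind; apply lsum_ext_in; intros x _; reflexivity).
      apply IHn.
      * intros i Hi. apply Hab; lia.
      * intros bx Hin i Hi. apply filter_In in Hin. apply Hbx; [tauto| lia].
      * intros z Hz. destruct (Hcov (upd z n t)) as [bx [Hin Hc]].
        { intros i Hi. unfold upd. destruct (Nat.eqb_spec i n) as [->|Hne]; auto. apply Hz; lia. }
        exists bx. split.
        -- apply filter_In. split; auto. apply decb_true.
           specialize (Hc n ltac:(lia)). unfold upd in Hc. rewrite Nat.eqb_refl in Hc. auto.
        -- intros i Hi. specialize (Hc i ltac:(lia)). unfold upd in Hc. destruct (Nat.eqb_spec i n); [lia|auto].
Qed.

Lemma prodd_enlarge : forall n (l : nat -> R) e, 0 < e ->
  exists eta, 0 < eta /\ prodd n (fun i => l i + 2 * eta) <= prodd n l + e.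
Proof.
  intros n l e He. pose proof near_0_right_mono as Hm.
  assert (Hc : forall n, lim_near near_0_right (fun eta => prodd n (fun i => l i + 2 * eta)) (prodd n l)).
  { induction n0; [unfold prodd; simpl; apply lim_near_const|].
    replace (fun eta => prodd (S n0) (fun i => l i + 2 * eta))
      with (fun eta => prodd n0 (fun i => l i + 2 * eta) * (l n0 + 2 * eta))
      by (apply functional_extensionality; intros; rewrite prodd_S; auto).
    assert (Hlin : lim_near near_0_right (fun eta => l n0 + 2 * eta) (l n0 + 2 * 0)).
    { apply lim_near_plus; auto; [apply lim_near_const|].
      apply lim_near_mult; auto; [apply lim_near_const| apply lim_near_id]. }
    rewrite Rmult_0_r, Rplus_0_r in Hlin. rewrite prodd_S. apply lim_near_mult; auto. }
  destruct (Hc n e He) as [del [Hdel H]]. exists (del / 2). split; [lra|].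
  specialize (H (del/2) ltac:(red; lra)). apply Rabs_def2 in H. lra.
Qed.

Definition in_box n (c : nat -> R) rho (z : nat -> R) : Prop :=
  forall i, (i < n)%nat -> c i - rho <= z i <= c i + rho.

Lemma box_finite_subcover : forall n (c : nat -> R) rho (lo hi : nat -> nat -> R),
  (forall z, in_box n c rho z -> exists k, forall i, (i < n)%nat -> lo k i < z i < hi k i) ->
  exists K, forall z, in_box n c rho z -> exists k, (k <= K)%nat /\ forall i, (i < n)%nat -> lo k i < z i < hi k i.
Proof.
  intros n c rho lo hi Hcov. apply NNPP; intro Hn.
  assert (Hs : forall K, exists z, in_box n c rho z /\ forall k, (k <= K)%nat ->
                 ~ (forall i, (i < n)%nat -> lo k i < z i < hi k i)).
  { intros K. apply NNPP; intro Hn2. apply Hn. exists K. intros z Hz. apply NNPP; intro Hn3.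
    apply Hn2. exists z. split; auto. intros k Hk Hin. apply Hn3. exists k; auto. }
  set (zs := fun K => proj1_sig (constructive_indefinite_description _ (Hs K))).
  assert (Hzs : forall K, in_box n c rho (zs K) /\ forall k, (k <= K)%nat ->
                 ~ (forall i, (i < n)%nat -> lo k i < zs K i < hi k i)).
  { intros K. unfold zs. destruct (constructive_indefinite_description _ (Hs K)); auto. }
  destruct (bounded_seq_cv_subseq_k n zs (l1d n c + rho)) as [phi [Z [Hphi HZ]]].
  { intros K i Hi. destruct (Hzs K) as [Hc _]. specialize (Hc i Hi).
    assert (Rabs (c i) <= l1d n c) by (apply (sumd_term_le n (fun i => Rabs (c i))); auto; intros; apply Rabs_pos).
    replace (zs K i) with (c i + (zs K i - c i)) by ring. eapply Rle_trans; [apply Rabs_triang|].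
    assert (Rabs (zs K i - c i) <= rho) by (apply Rabs_le; lra). lra. }
  assert (HZc : in_box n c rho Z).
  { intros i Hi. apply (Un_cv_bounds (fun m => zs (phi m) i)); auto. intros m. apply (proj1 (Hzs (phi m))); auto. }
  destruct (Hcov Z HZc) as [k0 Hk0].
  set (gap := fun i => Rmin (Z i - lo k0 i) (hi k0 i - Z i)).
  destruct (max_index_family n (fun i m => Rabs (zs (phi m) i - Z i) < gap i)) as [N0 HN0].
  { intros i Hi. specialize (Hk0 i Hi).
    destruct (HZ i Hi (gap i) ltac:(unfold gap; apply Rmin_pos; lra)) as [N HN].
    exists N. intros m Hm. apply HN; auto. }
  set (m := max N0 k0).
  destruct (Hzs (phi m)) as [_ Hnot]. apply (Hnot k0); [pose proof (strict_incr_ge phi Hphi m); lia|].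
  intros i Hi. specialize (HN0 i Hi m ltac:(lia)). specialize (Hk0 i Hi).
  pose proof (Rmin_l (Z i - lo k0 i) (hi k0 i - Z i)). pose proof (Rmin_r (Z i - lo k0 i) (hi k0 i - Z i)).
  fold (gap i) in *. apply Rabs_def2 in HN0. lra.
Qed.

Lemma box_not_null : forall n (c : nat -> R) rho, 0 < rho -> ~ null n (in_box n c rho).
Proof.
  intros n c rho Hrho Hnull.
  set (vol := prodd n (fun _ => 2 * rho)).
  assert (Hvol : 0 < vol) by (apply prodd_pos; intros; lra).
  destruct (Hnull (vol / 4) ltac:(lra)) as [lo [hi [H1 [H2 H3]]]].
  assert (Heta : forall k, exists eta, 0 < eta /\
     prodd n (fun i => (hi k i - lo k i) + 2 * eta) <= prodd n (fun i => hi k i - lo k i) + (vol / 4) / 2 ^ (S k)).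
  { intros k. apply prodd_enlarge. apply Rdiv_lt_0_compat; [lra| apply pow_lt; lra]. }
  set (eta := fun k => proj1_sig (constructive_indefinite_description _ (Heta k))).
  assert (Heta' : forall k, 0 < eta k /\
     prodd n (fun i => (hi k i - lo k i) + 2 * eta k) <= prodd n (fun i => hi k i - lo k i) + (vol / 4) / 2 ^ (S k)).
  { intros k. unfold eta. destruct (constructive_indefinite_description _ (Heta k)); auto. }
  destruct (box_finite_subcover n c rho (fun k i => lo k i - eta k) (fun k i => hi k i + eta k)) as [K HK].
  { intros z Hz. destruct (H2 z Hz) as [k Hk]. exists k. intros i Hi.
    specialize (Hk i Hi). pose proof (proj1 (Heta' k)). lra. }
  set (L := map (fun k => ((fun i => lo k i - eta k), (fun i => hi k i + eta k))) (seq 0 (S K))).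
  assert (Hle : prodd n (fun i => (c i + rho) - (c i - rho)) <= lsum (fun bx => prodd n (fun i => snd bx i - fst bx i)) L).
  { apply finite_box_cover_volume.
    - intros; lra.
    - intros bx Hin i Hi. unfold L in Hin. apply in_map_iff in Hin. destruct Hin as [k [<- _]]. simpl.
      specialize (H1 k i). pose proof (proj1 (Heta' k)). lra.
    - intros z Hz. destruct (HK z Hz) as [k [Hk Hin]].
      exists ((fun i => lo k i - eta k), (fun i => hi k i + eta k)). split.
      + unfold L. apply in_map_iff. exists k. split; auto. apply in_seq. lia.
      + intros i Hi. simpl. specialize (Hin i Hi). lra. }
  unfold L in Hle. rewrite lsum_map_seq in Hle. simpl in Hle.
  rewrite (prodd_ext n _ (fun _ => 2 * rho)) in Hle by (intros; ring). fold vol in Hle.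
  assert (Hs : sum_f_R0 (fun k => prodd n (fun i => hi k i + eta k - (lo k i - eta k))) K <=
               sum_f_R0 (fun k => prodd n (fun i => hi k i - lo k i)) K + (vol / 4) * sum_f_R0 (fun k => / 2 ^ S k) K).
  { rewrite scal_sum, <- plus_sum. apply sum_Rle. intros k _.
    rewrite (prodd_ext n _ (fun i => (hi k i - lo k i) + 2 * eta k)) by (intros; ring).
    pose proof (proj2 (Heta' k)). unfold Rdiv in *. lra. }
  rewrite sum_inv_pow2 in Hs. specialize (H3 K).
  assert (0 < / 2 ^ S K) by (apply Rinv_0_lt_compat, pow_lt; lra).
  nra.
Qed.

Lemma ae_on_box_witness : forall n (D P : (nat -> R) -> Prop) (c : nat -> R) rho, 0 < rho ->
  ae_on n D P -> (forall z, in_box n c rho z -> D z) -> exists z, in_box n c rho z /\ P z.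
Proof.
  intros n D P c rho Hrho Hae HD. apply NNPP; intro Hn.
  apply (box_not_null n c rho Hrho). apply (null_mono n _ _ Hae).
  intros z Hz. split; auto. intros HP. apply Hn. eauto.
Qed.

Lemma in_box_zx : forall n d c x z rb, (d < n)%nat -> (forall j, (j < d)%nat -> c (S j) = x j) ->
  in_box n c rb z -> normd d (vsub (zx d z) x) <= INR d * rb /\ inRd d (zx d z).
Proof.
  intros n d c x z rb Hdn Hc Hz. split.
  - eapply Rle_trans; [apply normd_le_l1d|]. unfold l1d. rewrite <- sumd_const. apply sumd_le. intros j Hj.
    unfold vsub, zx. destruct (Nat.ltb_spec j d); [|lia]. specialize (Hz (S j) ltac:(lia)).
    rewrite Hc in Hz by auto. apply Rabs_le; lra.
  - intros j Hj. unfold zx. destruct (Nat.ltb_spec j d); [lia|auto].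
Qed.

(** [(t, x, r)] and [(t, x)] as points of [R^(d+2)] and [R^(d+1)], read back by [zx]. *)
Definition zpt3 (d : nat) (t : R) (x : nat -> R) (r : R) : nat -> R :=
  fun i => match i with O => t | S j => if Nat.ltb j d then x j else if Nat.eqb j d then r else 0 end.

Definition zpt2 (d : nat) (t : R) (x : nat -> R) : nat -> R :=
  fun i => match i with O => t | S j => if Nat.ltb j d then x j else 0 end.

Lemma Om_near : forall d Om x, bounded_domain d Om -> Om x ->
  exists rx, 0 < rx /\ forall y, inRd d y -> normd d (vsub y x) < rx -> Om y.
Proof. intros d Om x HOm Hx. apply (proj2 (bounded_domain_open d Om HOm)); auto. Qed.

Lemma ae_txr_near : forall d T Om r0 (P : R -> (nat -> R) -> R -> Prop) t x r del,
  bounded_domain d Om -> oQR T Om r0 t x r -> 0 < del -> ae_txr d (oQR T Om r0) P ->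
  exists t' x' r', oQR T Om r0 t' x' r' /\ Rabs (t' - t) + normd d (vsub x' x) + Rabs (r' - r) < del /\
    P t' x' r'.
Proof.
  intros d T Om r0 P t x r del HOm [[Ht Hx] Hr] Hdel Hae.
  destruct (Om_near d Om x HOm Hx) as [rx [Hrx Hball]].
  set (del' := Rmin (Rmin del rx) (Rmin (Rmin t (T - t)) (r - r0))).
  assert (Hdel' : 0 < del') by (unfold del'; repeat apply Rmin_pos; lra).
  assert (Hd1 : del' <= del /\ del' <= rx /\ del' <= t /\ del' <= T - t /\ del' <= r - r0).
  { unfold del'. pose proof (Rmin_l (Rmin del rx) (Rmin (Rmin t (T - t)) (r - r0))).
    pose proof (Rmin_r (Rmin del rx) (Rmin (Rmin t (T - t)) (r - r0))).
    pose proof (Rmin_l del rx). pose proof (Rmin_r del rx). pose proof (Rmin_l (Rmin t (T - t)) (r - r0)).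
    pose proof (Rmin_r (Rmin t (T - t)) (r - r0)). pose proof (Rmin_l t (T - t)). pose proof (Rmin_r t (T - t)). lra. }
  pose proof (pos_INR d).
  set (rb := del' / (2 * (INR d + 3))).
  assert (Hrb : 0 < rb) by (unfold rb; apply Rdiv_lt_0_compat; lra).
  assert (Hrb2 : (INR d + 2) * rb < del') by (unfold rb; apply Rmult_lt_reg_r with (2 * (INR d + 3)); [lra|]; field_simplify; nra).
  assert (Hrb3 : rb < del') by nra.
  assert (Hxd : forall j, (j < d)%nat -> zpt3 d t x r (S j) = x j)
    by (intros j Hj; simpl; destruct (Nat.ltb_spec j d); [auto|lia]).
  assert (Hbox : forall z, in_box (S (S d)) (zpt3 d t x r) rb z ->
            oQR T Om r0 (z O) (zx d z) (z (S d)) /\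
            Rabs (z O - t) + normd d (vsub (zx d z) x) + Rabs (z (S d) - r) < del').
  { intros z Hz. destruct (in_box_zx (S (S d)) d _ x z rb ltac:(lia) Hxd Hz) as [Hzx Hzin].
    pose proof (Hz O ltac:(lia)) as Hzt. pose proof (Hz (S d) ltac:(lia)) as Hzr.
    simpl in Hzt, Hzr. rewrite Nat.ltb_irrefl, Nat.eqb_refl in Hzr.
    assert (Rabs (z O - t) <= rb) by (apply Rabs_le; lra).
    assert (Rabs (z (S d) - r) <= rb) by (apply Rabs_le; lra).
    assert (Hsum : Rabs (z O - t) + normd d (vsub (zx d z) x) + Rabs (z (S d) - r) < del') by nra.
    split; auto. split; [split; [lra|]|lra]. apply Hball; auto. pose proof (Rabs_pos (z O - t)).
    pose proof (Rabs_pos (z (S d) - r)). lra. }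
  destruct (ae_on_box_witness _ _ _ (zpt3 d t x r) rb Hrb Hae) as [z [Hz HP]].
  { intros z Hz. apply Hbox; auto. }
  exists (z O), (zx d z), (z (S d)). destruct (Hbox z Hz) as [Hq Hs]. split; [exact Hq|]. split; [lra| exact HP].
Qed.

Lemma ae_tx_near : forall d T Om (P : R -> (nat -> R) -> Prop) t x del,
  bounded_domain d Om -> oQ T Om t x -> 0 < del -> ae_tx d (oQ T Om) P ->
  exists t' x', oQ T Om t' x' /\ Rabs (t' - t) + normd d (vsub x' x) < del /\ P t' x'.
Proof.
  intros d T Om P t x del HOm [Ht Hx] Hdel Hae.
  destruct (Om_near d Om x HOm Hx) as [rx [Hrx Hball]].
  set (del' := Rmin (Rmin del rx) (Rmin t (T - t))).
  assert (Hdel' : 0 < del') by (unfold del'; repeat apply Rmin_pos; lra).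
  assert (Hd1 : del' <= del /\ del' <= rx /\ del' <= t /\ del' <= T - t).
  { unfold del'. pose proof (Rmin_l (Rmin del rx) (Rmin t (T - t))). pose proof (Rmin_r (Rmin del rx) (Rmin t (T - t))).
    pose proof (Rmin_l del rx). pose proof (Rmin_r del rx). pose proof (Rmin_l t (T - t)). pose proof (Rmin_r t (T - t)). lra. }
  pose proof (pos_INR d).
  set (rb := del' / (2 * (INR d + 3))).
  assert (Hrb : 0 < rb) by (unfold rb; apply Rdiv_lt_0_compat; lra).
  assert (Hrb2 : (INR d + 2) * rb < del') by (unfold rb; apply Rmult_lt_reg_r with (2 * (INR d + 3)); [lra|]; field_simplify; nra).
  assert (Hrb3 : rb < del') by nra.
  assert (Hxd : forall j, (j < d)%nat -> zpt2 d t x (S j) = x j)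
    by (intros j Hj; simpl; destruct (Nat.ltb_spec j d); [auto|lia]).
  assert (Hbox : forall z, in_box (S d) (zpt2 d t x) rb z ->
            oQ T Om (z O) (zx d z) /\ Rabs (z O - t) + normd d (vsub (zx d z) x) < del').
  { intros z Hz. destruct (in_box_zx (S d) d _ x z rb ltac:(lia) Hxd Hz) as [Hzx Hzin].
    pose proof (Hz O ltac:(lia)) as Hzt. simpl in Hzt.
    assert (Rabs (z O - t) <= rb) by (apply Rabs_le; lra).
    assert (Hsum : Rabs (z O - t) + normd d (vsub (zx d z) x) < del') by nra.
    split; auto. split; [lra|]. apply Hball; auto. pose proof (Rabs_pos (z O - t)). lra. }
  destruct (ae_on_box_witness _ _ _ (zpt2 d t x) rb Hrb Hae) as [z [Hz HP]].
  { intros z Hz. apply Hbox; auto. }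
  exists (z O), (zx d z). destruct (Hbox z Hz) as [Hq Hs]. split; [exact Hq|]. split; [lra| exact HP].
Qed.

Definition psi_equation d r0 (A tau : R -> R) (beta : R -> (nat -> R) -> (nat -> nat -> R) -> R)
    (v : nat -> R -> (nat -> R) -> R) (vx : nat -> nat -> R -> (nat -> R) -> R)
    (psi psit : R -> (nat -> R) -> R -> R) (psix : nat -> R -> (nat -> R) -> R -> R)
    (psixx : nat -> nat -> R -> (nat -> R) -> R -> R) (phi : R -> (nat -> R) -> R)
    (t : R) (x : nat -> R) (r : R) : Prop :=
  exists l I,
    derivable_pt_lim (fun s => pos (psi t x s)) r l /\
    HKint_inf (fun rt => beta rt (vecv d v t x) (symgrad d vx t x) * kappa r0 r rt * pos (psi t x rt)) r I /\
    psit t x r + sumd d (fun i => v i t x * psix i t x r) - A r * sumd d (fun i => psixx i i t x r)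
    = - beta r (vecv d v t x) (symgrad d vx t x) * psi t x r - tau r * phi t x * l + 2 * I.

Definition phi_equation d r0 A0 (tau taud : R -> R) (beta : R -> (nat -> R) -> (nat -> nat -> R) -> R)
    (v : nat -> R -> (nat -> R) -> R) (vx : nat -> nat -> R -> (nat -> R) -> R)
    (psi : R -> (nat -> R) -> R -> R) (phi phit : R -> (nat -> R) -> R) (phix : nat -> R -> (nat -> R) -> R)
    (phixx : nat -> nat -> R -> (nat -> R) -> R) (t : R) (x : nat -> R) : Prop :=
  exists I1 (J : R -> R) I2,
    HKint_inf (fun r => (tau r + r * taud r) * pos (psi t x r)) r0 I1 /\
    (forall r, 0 < r < r0 ->
       HKint_inf (fun rt => beta rt (vecv d v t x) (symgrad d vx t x) * kappa r0 r rt * pos (psi t x rt)) r0 (J r)) /\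
    HKint (fun r => r * J r) 0 r0 I2 /\
    phit t x + sumd d (fun i => v i t x * phix i t x) - A0 * sumd d (fun i => phixx i i t x) = - phi t x * I1 + 2 * I2.

Lemma pos_nonneg : forall s, 0 <= pos s.
Proof. intros. apply Rmax_r. Qed.

Lemma beta_pos : forall d r0 K beta eta (v : nat -> R -> (nat -> R) -> R) vx t x r,
  hypA3 d r0 K beta eta -> r0 < r -> 0 < beta r (vecv d v t x) (symgrad d vx t x).
Proof.
  intros d r0 K beta eta v vx t x r [_ [_ [Hb _]]] Hr. apply Hb; auto.
  - intros i Hi. unfold vecv. destruct (Nat.ltb_spec i d); [lia|auto].
  - intros i j Hij. unfold symgrad. destruct (Nat.ltb_spec i d); destruct (Nat.ltb_spec j d); simpl; auto; lia.
Qed.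

Lemma fragmentation_integral_nonneg : forall d r0 K beta eta v vx (psi : R -> (nat -> R) -> R -> R) t x r a I,
  hypA3 d r0 K beta eta ->
  HKint_inf (fun rt => beta rt (vecv d v t x) (symgrad d vx t x) * kappa r0 r rt * pos (psi t x rt)) a I -> 0 <= I.
Proof.
  intros d r0 K beta eta v vx psi t x r a I HA3 HI.
  apply (HKint_inf_nonneg_ae _ a I (fun _ => False) HI null1_False).
  intros rt _ _. apply Rmult_le_pos; [|apply pos_nonneg]. unfold kappa.
  destruct (Rlt_dec r0 rt) as [H1|H1]; [|lra].
  destruct (Rlt_dec 0 r); [|lra]. destruct (Rlt_dec r rt); [|lra].
  apply Rmult_le_pos; [apply Rlt_le; eapply beta_pos; eauto|]. apply Rlt_le, Rinv_0_lt_compat. lra.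
Qed.

(** By (A2), [tau + r tau' >= r0 / K > 0] for almost every [r > r0]. *)
Lemma growth_integral_nonneg : forall r0 K tau taud (psi : R -> R) I,
  0 < r0 -> 0 < K -> hypA2 r0 K tau taud ->
  HKint_inf (fun r => (tau r + r * taud r) * pos (psi r)) r0 I -> 0 <= I.
Proof.
  intros r0 K tau taud psi I Hr0 HK [_ [_ [_ [_ [_ [_ Hae]]]]]] HI.
  set (Q := fun s => derivable_pt_lim tau s (taud s) /\ / K * r0 <= tau s + s * taud s /\
                 tau s + taud s + s * taud s + tau s / s <= K).
  apply (HKint_inf_nonneg_ae _ r0 I (fun s => (r0 < s /\ ~ Q s) \/ s = r0) HI
           (null1_add_point (fun s => r0 < s /\ ~ Q s) r0 Hae)).
  intros s Hs Hn. apply Rmult_le_pos; [|apply pos_nonneg].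
  assert (Hs' : r0 < s) by (destruct (Req_dec s r0); [exfalso; apply Hn; right; auto| lra]).
  assert (Hq : Q s) by (apply NNPP; intro Hq; apply Hn; left; split; auto).
  destruct Hq as [_ [Hq _]]. assert (0 < / K * r0) by (apply Rmult_lt_0_compat; [apply Rinv_0_lt_compat|]; lra).
  lra.
Qed.

Lemma gain_integral_nonneg : forall r0 (J : R -> R) I, HKint (fun r => r * J r) 0 r0 I ->
  (forall r, 0 < r < r0 -> 0 <= J r) -> 0 <= I.
Proof.
  intros r0 J I HI HJ.
  apply (HKint_nonneg_ae _ 0 r0 I (fun s => False \/ s = r0) HI
           (null1_add_point (fun _ => False) r0 null1_False)).
  intros s Hs Hn. destruct (Req_dec s 0) as [->|Hs0]; [lra|].
  apply Rmult_le_pos; [lra|]. apply HJ. split; [lra|].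
  destruct (Req_dec s r0); [exfalso; apply Hn; right; auto| lra].
Qed.

Definition near3 d T Om r0 (t : R) (x : nat -> R) (r : R) : R -> R * (nat -> R) * R -> Prop :=
  fun del p => cQR d T Om r0 (fst (fst p)) (snd (fst p)) (snd p) /\
    Rabs (fst (fst p) - t) + normd d (vsub (snd (fst p)) x) + Rabs (snd p - r) < del.

Lemma near3_mono : forall d T Om r0 t x r, near_mono (near3 d T Om r0 t x r).
Proof. intros d T Om r0 t x r a b p Ha Hab [H1 H2]. split; auto. lra. Qed.

Lemma cont3_lim_near : forall d T Om r0 f t x r, cont3_on d (cQR d T Om r0) f -> cQR d T Om r0 t x r ->
  lim_near (near3 d T Om r0 t x r) (fun p => f (fst (fst p)) (snd (fst p)) (snd p)) (f t x r).
Proof.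
  intros d T Om r0 f t x r Hf Hc eps He. destruct (Hf t x r Hc eps He) as [del [Hdel H]].
  exists del. split; auto. intros [[t' x'] r'] [H1 H2]. simpl in *. apply H; auto.
Qed.

Lemma cont2_lim_near3 : forall d T Om r0 f t x r, cont2_on d (cQ d T Om) f -> cQR d T Om r0 t x r ->
  lim_near (near3 d T Om r0 t x r) (fun p => f (fst (fst p)) (snd (fst p))) (f t x).
Proof.
  intros d T Om r0 f t x r Hf [Hc _] eps He. destruct (Hf t x Hc eps He) as [del [Hdel H]].
  exists del. split; auto. intros [[t' x'] r'] [[H1 _] H2]. simpl in *. apply H; auto.
  pose proof (Rabs_pos (r' - r)). lra.
Qed.

Lemma continuity_pt_lim_near3 : forall d T Om r0 (A : R -> R) t x r, continuity_pt A r ->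
  lim_near (near3 d T Om r0 t x r) (fun p => A (snd p)) (A r).
Proof.
  intros d T Om r0 A t x r HA eps He. destruct (continuity_pt_eps A r HA eps He) as [del [Hdel H]].
  exists del. split; auto. intros [[t' x'] r'] [_ H2]. simpl in *. apply H.
  pose proof (Rabs_pos (t' - t)). pose proof (normd_nonneg d (vsub x' x)). lra.
Qed.

Lemma cont3_slice : forall d T Om r0 f r, r0 <= r -> cont3_on d (cQR d T Om r0) f ->
  cont2_on d (cQ d T Om) (fun t x => f t x r).
Proof.
  intros d T Om r0 f r Hr Hf t x Hc eps He. destruct (Hf t x r (conj Hc Hr) eps He) as [del [Hdel H]].
  exists del. split; auto. intros t' x' Hc' Hn. apply H; [split; auto|]. rewrite Rminus_diag, Rabs_R0. lra.
Qed.

Section PsiEquation.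

Variables (d : nat) (T r0 K : R) (Om : (nat -> R) -> Prop) (A tau eta : R -> R).
Variable beta : R -> (nat -> R) -> (nat -> nat -> R) -> R.
Variables (v vt : nat -> R -> (nat -> R) -> R) (vx : nat -> nat -> R -> (nat -> R) -> R).
Variables (psi psit psir : R -> (nat -> R) -> R -> R) (psix : nat -> R -> (nat -> R) -> R -> R).
Variable psixx : nat -> nat -> R -> (nat -> R) -> R -> R.
Variable phi : R -> (nat -> R) -> R.
Hypothesis HOm : bounded_domain d Om.
Hypothesis HA1 : hypA1 r0 A.
Hypothesis HA3 : hypA3 d r0 K beta eta.
Hypothesis Hv : reg_v d T Om v vt vx.
Hypothesis Hpsi : reg_psi d T Om r0 psi psit psir psix psixx.
Hypothesis Heq : ae_txr d (oQR T Om r0) (psi_equation d r0 A tau beta v vx psi psit psix psixx phi).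

Let psi_td (t : R) (x : nat -> R) (r : R) : R :=
  transport_diffusion d v (A r) (fun t x => psit t x r) (fun i t x => psix i t x r) (fun i j t x => psixx i j t x r) t x.

Lemma psi_td_lim_near : forall t x r, r0 < r -> cQR d T Om r0 t x r ->
  lim_near (near3 d T Om r0 t x r) (fun p => psi_td (fst (fst p)) (snd (fst p)) (snd p)) (psi_td t x r).
Proof.
  intros t x r Hr Hc. pose proof (near3_mono d T Om r0 t x r) as Hm.
  destruct Hpsi as [[_ [Cpsit [_ [Cpsix Cpsixx]]]] _].
  unfold psi_td, transport_diffusion. apply lim_near_minus; auto.
  - apply lim_near_plus; auto; [apply (cont3_lim_near d T Om r0 psit); auto|].
    apply (lim_near_sumd _ _ d (fun i p => v i (fst (fst p)) (snd (fst p)) * psix i (fst (fst p)) (snd (fst p)) (snd p))); auto.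
    intros i Hi. apply lim_near_mult; auto.
    + apply (cont2_lim_near3 d T Om r0 (v i)); auto. apply (proj1 Hv); auto.
    + apply (cont3_lim_near d T Om r0 (psix i)); auto.
  - apply lim_near_mult; auto; [apply continuity_pt_lim_near3; apply HA1; auto|].
    apply (lim_near_sumd _ _ d (fun i p => psixx i i (fst (fst p)) (snd (fst p)) (snd p))); auto.
    intros i Hi. apply (cont3_lim_near d T Om r0 (psixx i i)); auto.
Qed.

(** Where [psi < 0], [psi_+] vanishes nearby, so [d_r psi_+ = 0] and the equation reads
    [psi_td = - beta psi + 2 I > 0]. *)
Lemma psi_td_nonneg : forall t x r, oQR T Om r0 t x r -> psi t x r < 0 -> 0 <= psi_td t x r.
Proof.
  intros t x r Hq Hneg. apply Rnot_lt_le; intro HR.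
  destruct Hq as [[Ht Hx] Hr].
  assert (Hc3 : cQR d T Om r0 t x r)
    by (split; [split; [lra| apply open_in_closure; auto; apply bounded_domain_open; auto]| lra]).
  destruct (psi_td_lim_near t x r Hr Hc3 (- psi_td t x r / 2) ltac:(lra)) as [d1 [Hd1 H1]].
  destruct (proj1 (proj1 Hpsi) t x r Hc3 (- psi t x r / 2) ltac:(lra)) as [d2 [Hd2 H2]].
  set (del := Rmin (Rmin d1 d2) (r - r0)).
  assert (Hdel : 0 < del /\ del <= d1 /\ del <= d2 /\ del <= r - r0).
  { unfold del. pose proof (Rmin_l (Rmin d1 d2) (r - r0)). pose proof (Rmin_r (Rmin d1 d2) (r - r0)).
    pose proof (Rmin_l d1 d2). pose proof (Rmin_r d1 d2). repeat split; try lra. repeat apply Rmin_pos; lra. }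
  destruct (ae_txr_near d T Om r0 _ t x r (del / 2) HOm (conj (conj Ht Hx) Hr) ltac:(lra) Heq)
    as [t' [x' [r' [[[Ht' Hx'] Hr'] [Hdist [l [I [Hl [HI Heqn]]]]]]]]].
  assert (Hcl' : closure d Om x') by (apply open_in_closure; auto; apply bounded_domain_open; auto).
  pose proof (Rabs_pos (t' - t)). pose proof (normd_nonneg d (vsub x' x)). pose proof (Rabs_pos (r' - r)).
  assert (Hrr : Rabs (r' - r) < del / 2) by lra. apply Rabs_def2 in Hrr.
  assert (Hnear : forall s, Rabs (s - r') < del / 2 ->
            cQR d T Om r0 t' x' s /\ Rabs (t' - t) + normd d (vsub x' x) + Rabs (s - r) < d2).
  { intros s Hs. pose proof Hs as Hs'. apply Rabs_def2 in Hs'.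
    assert (Rabs (s - r) <= Rabs (s - r') + Rabs (r' - r))
      by (replace (s - r) with ((s - r') + (r' - r)) by ring; apply Rabs_triang).
    split; [split; [split; [lra|auto]| lra]| lra]. }
  assert (Hpsi_neg : forall s, Rabs (s - r') < del / 2 -> psi t' x' s < 0).
  { intros s Hs. destruct (Hnear s Hs) as [Hc Hd]. specialize (H2 t' x' s Hc Hd).
    apply Rabs_def2 in H2. lra. }
  assert (Hl0 : l = 0).
  { apply (derivable_locally_zero _ r' l Hl). exists (del / 2). split; [lra|]. intros s Hs.
    apply Rmax_right. apply Rlt_le, Hpsi_neg; auto. }
  assert (HI0 : 0 <= I) by (eapply fragmentation_integral_nonneg; eauto).
  assert (Hb : 0 < beta r' (vecv d v t' x') (symgrad d vx t' x')) by (eapply beta_pos; eauto).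
  assert (Hpsi' : psi t' x' r' < 0) by (apply Hpsi_neg; rewrite Rminus_diag, Rabs_R0; lra).
  assert (HRf : psi_td t' x' r' < 0).
  { assert (Hn3 : near3 d T Om r0 t x r d1 (t', x', r')).
    { split; [|simpl; lra]. apply (proj1 (Hnear r' ltac:(rewrite Rminus_diag, Rabs_R0; lra))). }
    specialize (H1 (t', x', r') Hn3). simpl in H1. apply Rabs_def2 in H1. lra. }
  unfold psi_td, transport_diffusion in HRf. rewrite Heqn, Hl0 in HRf.
  nra.
Qed.

Lemma psi_nonneg : forall n, C11_boundary_normal d Om n ->
  (forall t x r, 0 < t < T -> bdry d Om x -> r0 < r -> sumd d (fun i => psix i t x r * n x i) = 0) ->
  (forall x r, closure d Om x -> r0 <= r -> 0 <= psi 0 x r) ->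
  forall t x r, oQR T Om r0 t x r -> 0 <= psi t x r.
Proof.
  intros n Hn Hneu Hinit t x r [Hox Hr].
  destruct Hpsi as [[Cpsi [Cpsit [_ [Cpsix Cpsixx]]]] [Hder _]].
  apply (parabolic_min_principle d T Om n (fun t x => psi t x r) (fun t x => psit t x r)
           (fun i t x => psix i t x r) (fun i j t x => psixx i j t x r) v (A r)); auto.
  - apply Rlt_le, HA1; auto.
  - apply (cont3_slice d T Om r0); auto; lra.
  - apply (cont3_slice d T Om r0); auto; lra.
  - intros i Hi. apply (cont3_slice d T Om r0); auto; lra.
  - intros i j Hi Hj. apply (cont3_slice d T Om r0); auto; lra.
  - intros i Hi. apply (proj1 Hv); auto.
  - intros t' x' Ho. destruct (Hder t' x' r (conj Ho Hr)) as [H1 [_ [H3 H4]]]. auto.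
  - intros x' Hx'. apply Hinit; auto; lra.
  - intros t' x' Ho Hneg. apply psi_td_nonneg; auto. split; auto.
Qed.

End PsiEquation.

Section PhiEquation.

Variables (d : nat) (T r0 K A0 : R) (Om : (nat -> R) -> Prop) (tau taud eta : R -> R).
Variable beta : R -> (nat -> R) -> (nat -> nat -> R) -> R.
Variables (v vt : nat -> R -> (nat -> R) -> R) (vx : nat -> nat -> R -> (nat -> R) -> R).
Variable psi : R -> (nat -> R) -> R -> R.
Variables (phi phit : R -> (nat -> R) -> R) (phix : nat -> R -> (nat -> R) -> R).
Variable phixx : nat -> nat -> R -> (nat -> R) -> R.
Hypothesis Hr0 : 0 < r0.
Hypothesis HK : 0 < K.
Hypothesis HOm : bounded_domain d Om.
Hypothesis HA2 : hypA2 r0 K tau taud.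
Hypothesis HA3 : hypA3 d r0 K beta eta.
Hypothesis Hv : reg_v d T Om v vt vx.
Hypothesis Hphi : reg_phi d T Om phi phit phix phixx.
Hypothesis Heq : ae_tx d (oQ T Om) (phi_equation d r0 A0 tau taud beta v vx psi phi phit phix phixx).

(** Both integrals in the equation for [phi] are nonnegative, so [phi < 0] makes its right-hand
    side nonnegative nearby. *)
Lemma phi_td_nonneg : forall t x, oQ T Om t x -> phi t x < 0 -> 0 <= transport_diffusion d v A0 phit phix phixx t x.
Proof.
  intros t x Hox Hneg. apply Rnot_lt_le; intro HR.
  destruct Hphi as [[Cphi [Cphit [Cphix Cphixx]]] _].
  assert (Hc : cQ d T Om t x)
    by (destruct Hox; split; [lra| apply open_in_closure; auto; apply bounded_domain_open; auto]).
  assert (Ctd : cont2_on d (cQ d T Om) (transport_diffusion d v A0 phit phix phixx))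
    by (apply cont2_transport_diffusion; auto; intros i Hi; apply (proj1 Hv); auto).
  destruct (Ctd t x Hc (- transport_diffusion d v A0 phit phix phixx t x / 2) ltac:(lra)) as [d1 [Hd1 H1]].
  destruct (Cphi t x Hc (- phi t x / 2) ltac:(lra)) as [d2 [Hd2 H2]].
  destruct (ae_tx_near d T Om _ t x (Rmin d1 d2) HOm Hox (Rmin_pos _ _ Hd1 Hd2) Heq)
    as [t' [x' [[Ht' Hx'] [Hdist [I1 [J [I2 [HI1 [HJ [HI2 Heqn]]]]]]]]]].
  assert (Hc' : cQ d T Om t' x')
    by (split; [lra| apply open_in_closure; auto; apply bounded_domain_open; auto]).
  pose proof (Rmin_l d1 d2). pose proof (Rmin_r d1 d2).
  assert (HI10 : 0 <= I1) by exact (growth_integral_nonneg r0 K tau taud (psi t' x') I1 Hr0 HK HA2 HI1).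
  assert (HI20 : 0 <= I2).
  { apply (gain_integral_nonneg r0 J I2 HI2). intros r Hr. eapply fragmentation_integral_nonneg; eauto. }
  specialize (H1 t' x' Hc' ltac:(lra)). specialize (H2 t' x' Hc' ltac:(lra)).
  apply Rabs_def2 in H1. apply Rabs_def2 in H2.
  unfold transport_diffusion in H1. rewrite Heqn in H1. nra.
Qed.

Lemma phi_nonneg : forall n, C11_boundary_normal d Om n ->
  (forall t x, 0 < t < T -> bdry d Om x -> sumd d (fun i => phix i t x * n x i) = 0) ->
  (forall x, closure d Om x -> 0 <= phi 0 x) -> 0 < A0 ->
  forall t x, oQ T Om t x -> 0 <= phi t x.
Proof.
  intros n Hn Hneu Hinit HA0.
  destruct Hphi as [[Cphi [Cphit [Cphix Cphixx]]] Hder].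
  apply (parabolic_min_principle d T Om n phi phit phix phixx v A0); auto.
  - lra.
  - intros i Hi. apply (proj1 Hv); auto.
  - intros t x Ho Hneg. apply phi_td_nonneg; auto.
Qed.

End PhiEquation.

Lemma ae_of_everywhere : forall n (D P : (nat -> R) -> Prop), (0 < n)%nat -> (forall z, D z -> P z) -> ae_on n D P.
Proof. intros n D P Hn H. apply null_empty; auto. intros z [HD HnP]. auto. Qed.

Theorem lemma3p1
  (d : nat) (T r0 K A0 : R)
  (Om : (nat -> R) -> Prop) (n : (nat -> R) -> nat -> R)
  (A tau taud eta : R -> R)
  (beta : R -> (nat -> R) -> (nat -> nat -> R) -> R)
  (v vt : nat -> R -> (nat -> R) -> R) (vx : nat -> nat -> R -> (nat -> R) -> R)
  (psi psit psir : R -> (nat -> R) -> R -> R)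
  (psix : nat -> R -> (nat -> R) -> R -> R)
  (psixx : nat -> nat -> R -> (nat -> R) -> R -> R)
  (phi phit : R -> (nat -> R) -> R)
  (phix : nat -> R -> (nat -> R) -> R)
  (phixx : nat -> nat -> R -> (nat -> R) -> R)
  (Hd : d = 2%nat \/ d = 3%nat)
  (HT : 0 < T) (Hr0 : 0 < r0) (HK : 0 < K) (HA0 : 0 < A0)
  (HOm : bounded_domain d Om)
  (Hn : C11_boundary_normal d Om n)
  (HA1 : hypA1 r0 A)
  (HA2 : hypA2 r0 K tau taud)
  (HA3 : hypA3 d r0 K beta eta)
  (* (A4) is built into [kappa] *)
  (Hv : reg_v d T Om v vt vx)
  (Hdiv : forall t x, oQ T Om t x -> sumd d (fun i => vx i i t x) = 0)
  (Hvn : forall t x, 0 < t < T -> bdry d Om x -> sumd d (fun i => v i t x * n x i) = 0)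
  (Hpsi : reg_psi d T Om r0 psi psit psir psix psixx)
  (Hphi : reg_phi d T Om phi phit phix phixx)
  (Hpsin : forall t x r, 0 < t < T -> bdry d Om x -> r0 < r ->
            sumd d (fun i => psix i t x r * n x i) = 0)
  (Hphin : forall t x, 0 < t < T -> bdry d Om x ->
            sumd d (fun i => phix i t x * n x i) = 0)
  (Hpsi0 : forall x r, closure d Om x -> r0 <= r -> 0 <= psi 0 x r)
  (Hphi0 : forall x, closure d Om x -> 0 <= phi 0 x)
  (Heqpsi : ae_txr d (oQR T Om r0) (fun t x r =>
      exists l I,
        derivable_pt_lim (fun s => pos (psi t x s)) r l /\
        HKint_inf (fun rt => beta rt (vecv d v t x) (symgrad d vx t x)
                              * kappa r0 r rt * pos (psi t x rt)) r I /\
        psit t x r + sumd d (fun i => v i t x * psix i t x r)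
          - A r * sumd d (fun i => psixx i i t x r)
        = - beta r (vecv d v t x) (symgrad d vx t x) * psi t x r
          - tau r * phi t x * l + 2 * I))
  (Heqphi : ae_tx d (oQ T Om) (fun t x =>
      exists I1 (J : R -> R) I2,
        HKint_inf (fun r => (tau r + r * taud r) * pos (psi t x r)) r0 I1 /\
        (forall r, 0 < r < r0 ->
           HKint_inf (fun rt => beta rt (vecv d v t x) (symgrad d vx t x)
                                 * kappa r0 r rt * pos (psi t x rt)) r0 (J r)) /\
        HKint (fun r => r * J r) 0 r0 I2 /\
        phit t x + sumd d (fun i => v i t x * phix i t x)
          - A0 * sumd d (fun i => phixx i i t x)
        = - phi t x * I1 + 2 * I2)) :
  ae_txr d (oQR T Om r0) (fun t x r => 0 <= psi t x r) /\
  ae_tx d (oQ T Om) (fun t x => 0 <= phi t x).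
Proof.
  split; apply ae_of_everywhere; try lia; intros z Hz.
  - apply (psi_nonneg d T r0 K Om A tau eta beta v vt vx psi psit psir psix psixx phi HOm HA1 HA3 Hv Hpsi Heqpsi n);
      auto.
  - apply (phi_nonneg d T r0 K A0 Om tau taud eta beta v vt vx psi phi phit phix phixx Hr0 HK HOm HA2 HA3 Hv Hphi Heqphi n);
      auto.
Qed.
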